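(* Consider the piecewise smooth vector field $X$ below. If $a_1+a_2+a_3+a_4\neq0$ and $\alpha^*:=-\dfrac{2(b_1-b_2-b_3+b_4)}{a_1+a_2+a_3+a_4}>0$, then for $|\varepsilon|\neq0$ sufficiently small $X$ has an isolated periodic orbit crossing the discontinuity set $\{uv=0\}$ and passing through a point at distance $\mathcal O(\varepsilon)$ from $(\alpha^*,0,0)$ (equivalently, $\alpha^*$ is a simple zero of the first order bifurcation function $f_1(\alpha)=\frac12\alpha\big(\alpha(a_1+a_2+a_3+a_4)+2(b_1-b_2-b_3+b_4)\big)$).
   Context: Let $a_j,b_j,c_j,d_j\in\mathbb R$, $j=1,\dots,4$. The vector field on $\mathbb R^3$ (coordinates $(u,v,w)$) is $X=X_1$ on $\{u>0,v>0\}$, $X_2$ on $\{u<0,v>0\}$, $X_3$ on $\{u<0,v<0\}$, $X_4$ on $\{u>0,v<0\}$, where $X_1=(-1+\varepsilon(a_1u+b_1),\,1,\,-w+\varepsilon(c_1u+d_1))$, $X_2=(-1+\varepsilon(a_2u+b_2),\,-1,\,-w+\varepsilon(c_2u+d_2))$, $X_3=(1+\varepsilon(a_3u+b_3),\,-1,\,-w+\varepsilon(c_3u+d_3))$, $X_4=(1+\varepsilon(a_4u+b_4),\,1,\,-w+\varepsilon(c_4u+d_4))$. Trajectories follow Filippov's convention (crossing by concatenation). For $\varepsilon=0$ the plane $w=0$ is filled by the periodic orbits $|u|+|v|=\alpha$, $\alpha>0$. *)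

From Stdlib Require Import Reals Lra List.
Open Scope R_scope.

(* Parameters a_j, b_j, c_j, d_j are given as functions nat -> R, only the
   indices j = 1..4 are used. *)

Definition su (j : nat) : R :=
  match j with 1%nat | 2%nat => -1 | _ => 1 end.
Definition sv (j : nat) : R :=
  match j with 1%nat | 4%nat => 1 | _ => -1 end.

Definition Xu (a b : nat -> R) (eps : R) (j : nat) (u : R) : R :=
  su j + eps * (a j * u + b j).
Definition Xv (j : nat) : R := sv j.
Definition Xw (c d : nat -> R) (eps : R) (j : nat) (u w : R) : R :=
  - w + eps * (c j * u + d j).

Definition in_region (j : nat) (u v : R) : Prop :=
  match j with
  | 1%nat => 0 < u /\ 0 < v
  | 2%nat => u < 0 /\ 0 < v
  | 3%nat => u < 0 /\ v < 0
  | 4%nat => 0 < u /\ v < 0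
  | _ => False
  end.

(* A periodic orbit of the piecewise smooth field X (Filippov, crossing by
   concatenation): a continuous, T-periodic curve (T > 0) which meets the
   discontinuity set {uv = 0} only at finitely many times per period, and which
   outside of those times solves the ODE of the field of the quadrant it is in. *)
Definition periodic_orbit (a b c d : nat -> R) (eps : R)
    (gu gv gw : R -> R) : Prop :=
  (forall t, continuity_pt gu t /\ continuity_pt gv t /\ continuity_pt gw t) /\
  exists T : R, 0 < T /\
    (forall t, gu (t + T) = gu t /\ gv (t + T) = gv t /\ gw (t + T) = gw t) /\
    (exists L : list R, forall t, 0 <= t <= T -> gu t * gv t = 0 -> In t L) /\
    (forall t j, in_region j (gu t) (gv t) ->
       derivable_pt_lim gu t (Xu a b eps j (gu t)) /\
       derivable_pt_lim gv t (Xv j) /\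
       derivable_pt_lim gw t (Xw c d eps j (gu t) (gw t))).

Definition dist3 (x1 y1 z1 x2 y2 z2 : R) : R :=
  sqrt ((x1 - x2)^2 + (y1 - y2)^2 + (z1 - z2)^2).

Definition on_orbit (gu gv gw : R -> R) (x y z : R) : Prop :=
  exists t, gu t = x /\ gv t = y /\ gw t = z.

(* Isolated: some neighbourhood (radius r) of the orbit contains no other
   periodic orbit (i.e. every periodic orbit lying inside it has the same image). *)
Definition isolated_periodic_orbit (a b c d : nat -> R) (eps : R)
    (gu gv gw : R -> R) : Prop :=
  periodic_orbit a b c d eps gu gv gw /\
  exists r : R, 0 < r /\
    forall hu hv hw : R -> R,
      periodic_orbit a b c d eps hu hv hw ->
      (forall s, exists t, dist3 (hu s) (hv s) (hw s) (gu t) (gv t) (gw t) < r) ->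
      forall x y z, on_orbit hu hv hw x y z <-> on_orbit gu gv gw x y z.

Definition alpha_star (a b : nat -> R) : R :=
  - (2 * (b 1%nat - b 2%nat - b 3%nat + b 4%nat)) /
    (a 1%nat + a 2%nat + a 3%nat + a 4%nat).

From Stdlib Require Import Reals Lra Lia List Classical ZArith.
From Coquelicot Require Import Coquelicot.
Open Scope R_scope.

(* In each quadrant the field is linear and [v' = +-1], so the orbit through a point (0, Y)
   of the positive v-axis can be written down explicitly: it reaches the negative v-axis at
   (0, -Z) and the positive one again at (0, Y'), where [left_transit a b e Y Z] and
   [right_transit a b e Z Y'] hold.  Writing Z = Z1(Y) for the forward and Z = Z2(Y) for the
   backward transit, ln Z1(Y) - ln Z2(Y) = e (b1 - b2 - b3 + b4 + (a1 + a2 + a3 + a4) Y / 2)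
   + O(e^2), i.e. e f1(Y) / Y + O(e^2); since alpha_star is a simple zero, the intermediate
   value theorem gives a closed orbit through (0, y) with y = alpha_star + O(e).  The
   w-equation is linear and contracting, which fixes the w-component.

   The slope of the return map near alpha_star is exp (- e (b1 - b2 - b3 + b4) + o(e)),
   hence different from 1.  Any periodic orbit in a thin tube around the closed orbit meets
   the positive v-axis at finitely many heights, permuted by the return map; monotonicity of
   Y - Y' then forces all of them to equal y, so the orbit coincides with the constructed
   one, which is therefore isolated. *)

(** * Elementary bounds on [exp] and [ln] *)

Lemma exp_le_inv x y : exp x <= exp y -> x <= y.
Proof. intros H. destruct (Rle_dec x y); auto. assert (exp y < exp x) by (apply exp_increasing;
  lra). lra. Qed.

Lemma exp_le_mono x y : x <= y -> exp x <= exp y.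
Proof. intros H. destruct H. left; apply exp_increasing; auto. subst; lra. Qed.

Lemma exp_le_inv_1minus x : x < 1 -> exp x <= / (1 - x).
Proof.
  intros H. assert (h := exp_ineq1_le (-x)). rewrite exp_Ropp in h.
  assert (0 < exp x) by apply exp_pos.
  apply Rmult_le_reg_r with (1-x). lra. rewrite Rinv_l by lra.
  apply Rmult_le_reg_r with (/ exp x). apply Rinv_0_lt_compat; auto.
  rewrite Rmult_1_l. replace (exp x * (1-x) * / exp x) with (1-x) by (field; lra). lra.
Qed.

Lemma Rabs_exp_sub1_le x : Rabs x <= /2 -> Rabs (exp x - 1) <= 2 * Rabs x.
Proof.
  intros H. assert (h1 := exp_ineq1_le x).
  destruct (Rle_dec 0 x).
  - assert (h2 := exp_le_inv_1minus x ltac:(apply Rabs_le_between in H; lra)).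
    rewrite Rabs_right by lra. rewrite Rabs_right in H |- * by lra.
    assert (/ (1-x) <= 1 + 2*x).
    { apply Rmult_le_reg_r with (1-x). lra. rewrite Rinv_l by lra. nra. }
    lra.
  - rewrite Rabs_left in H by lra. rewrite (Rabs_left x) by lra.
    assert (exp x < 1) by (rewrite <- exp_0; apply exp_increasing; lra).
    rewrite Rabs_left by lra. lra.
Qed.

Lemma ln_1plus_le x : 0 < 1 + x -> ln (1 + x) <= x.
Proof.
  intros H. apply exp_le_inv. rewrite exp_ln by auto. apply exp_ineq1_le.
Qed.

Lemma ln_1plus_ge x : Rabs x <= /2 -> x - 2 * x^2 <= ln (1 + x).
Proof.
  intros H. apply Rabs_le_between in H.
  assert (h : ln (/ (1 + x)) <= - x / (1 + x)).
  { replace (/ (1+x)) with (1 + (- x / (1+x))) by (field; lra). apply ln_1plus_le.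
    replace (1 + - x / (1 + x)) with (/ (1+x)) by (field; lra). apply Rinv_0_lt_compat; lra. }
  rewrite ln_Rinv in h by lra.
  assert (x / (1+x) >= x - 2 * x^2).
  { apply Rle_ge. apply Rmult_le_reg_r with (1+x). lra.
    replace (x / (1+x) * (1+x)) with x by (field; lra). nra. }
  unfold Rdiv in *. lra.
Qed.

Lemma Rabs_ln_1plus_sub_le x : Rabs x <= /2 -> Rabs (ln (1 + x) - x) <= 2 * x^2.
Proof.
  intros H. assert (h1 := ln_1plus_ge x H). assert (h2 := ln_1plus_le x ltac:(apply Rabs_le_between
    in H; lra)).
  apply Rabs_le_between. split; nra.
Qed.

Lemma ln_1plus_bounds u eta : Rabs u <= eta -> eta <= /2 -> Rabs (ln (1+u)) <= 2 * eta
  /\ Rabs (ln (1 + u) - u) <= 2 * eta^2.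
Proof.
  intros h1 h2. assert (k := Rabs_ln_1plus_sub_le u ltac:(lra)).
  assert (u^2 <= eta^2) by (rewrite <- (pow2_abs u); apply pow_incr; split; auto; apply Rabs_pos).
  assert (eta^2 <= eta/2) by (assert (0 <= Rabs u) by apply Rabs_pos; nra).
  split. 2: lra.
  apply Rabs_le_between in k. apply Rabs_le_between in h1. apply Rabs_le_between. split; nra.
Qed.

Lemma cosh2_ge2 s : 2 <= exp s + exp (-s).
Proof.
  assert (h : exp s * exp (-s) = 1) by (rewrite <- exp_plus; replace (s + -s) with 0 by ring; apply exp_0).
  assert (0 < exp s) by apply exp_pos. assert (0 < exp (-s)) by apply exp_pos.
  assert (exp s * (exp s + exp (-s) - 2) = (exp s - 1)^2).
  { replace (exp s * (exp s + exp (-s) - 2)) with (exp s * exp s + exp s * exp(-s) - 2 * exp s) by ring.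
    rewrite h. ring. }
  assert (0 <= (exp s - 1)^2) by apply pow2_ge_0.
  destruct (Rle_dec 2 (exp s + exp (-s))) as [|n]; auto. apply Rnot_le_lt in n. nra.
Qed.

Lemma sinh2_ge s : 0 <= s -> 2 * s <= exp s - exp (-s).
Proof.
  intros H. destruct H as [H|H]; [|subst; rewrite Ropp_0; lra].
  destruct (MVT_cor2 (fun t => exp t - exp (-t) - 2*t) (fun t => exp t + exp (-t) - 2) 0 s H) as [c [Hc _]].
  { intros c _. apply is_derive_Reals. auto_derive; auto. ring. }
  assert (h := cosh2_ge2 c). rewrite Ropp_0, exp_0 in Hc. nra.
Qed.

Lemma sinh2_le_cosh2 s : 0 <= s -> exp s - exp (-s) <= s * (exp s + exp (-s)).
Proof.
  intros H. destruct H as [H|H]; [|subst; rewrite Ropp_0; lra].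
  destruct (MVT_cor2 (fun t => t * (exp t + exp (-t)) - (exp t - exp (-t)))
    (fun t => t * (exp t - exp (-t))) 0 s H) as [c [Hc [Hc1 Hc2]]].
  { intros c _. apply is_derive_Reals. auto_derive; auto. ring. }
  assert (exp (-c) < exp c) by (apply exp_increasing; lra).
  rewrite Ropp_0, exp_0 in Hc.
  assert (0 <= c*(exp c - exp(-c))*(s-0)) by (apply Rmult_le_pos; [apply Rmult_le_pos|]; lra). lra.
Qed.

Lemma exp_half_le2 : exp (/2) <= 2.
Proof.
  assert (h : exp (/2) * exp (/2) = exp 1) by (rewrite <- exp_plus; f_equal; field).
  assert (h3 := exp_le_3). assert (0 < exp (/2)) by apply exp_pos. nra.
Qed.

Lemma exp_opp_half_ge : / 2 <= exp (- / 2).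
Proof.
  rewrite exp_Ropp. assert (h := exp_half_le2). assert (0 < exp (/2)) by apply exp_pos.
  apply Rinv_le_contravar; lra.
Qed.

Lemma exp_small_bounds t : Rabs t <= /2 -> /2 <= exp t <= 2.
Proof.
  intros H. apply Rabs_le_between in H. split.
  - apply Rle_trans with (exp (-/2)). apply exp_opp_half_ge. apply exp_le_mono; lra.
  - apply Rle_trans with (exp (/2)). apply exp_le_mono; lra. apply exp_half_le2.
Qed.

Lemma cosh2_le s : Rabs s <= 1 -> exp s + exp (-s) <= 2 + 9/4 * s^2.
Proof.
  intros H.
  assert (Hsq : exp s + exp (-s) - 2 = (exp (s/2) - exp (-(s/2)))^2).
  { replace s with (s/2 + s/2) at 1 by field. replace (-s) with (-(s/2) + -(s/2)) at 1 by field.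
    rewrite !exp_plus. assert (exp (s/2) * exp (-(s/2)) = 1).
    { rewrite <- exp_plus. replace (s / 2 + - (s / 2)) with 0 by ring. apply exp_0. } nra. }
  assert (Hb : forall u, 0 <= u <= /2 -> 0 <= exp u - exp (-u) <= 3 * u).
  { intros u Hu. split. assert (exp (-u) <= exp u) by (apply exp_le_mono; lra). lra.
    assert (h1 := sinh2_le_cosh2 u ltac:(lra)). assert (exp u <= 2).
    { apply Rle_trans with (exp (/2)). apply exp_le_mono; lra. apply exp_half_le2. }
    assert (exp (-u) <= 1) by (rewrite <- exp_0; apply exp_le_mono; lra). nra. }
  apply Rabs_le_between in H.
  destruct (Rle_dec 0 s).
  - destruct (Hb (s/2)) as [h1 h2]. lra.
    assert ((exp (s/2) - exp (-(s/2)))^2 <= (3*(s/2))^2) by (apply pow_incr; lra). nra.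
  - destruct (Hb (-(s/2))) as [h1 h2]. lra. rewrite Ropp_involutive in h1, h2.
    assert ((exp (-(s/2)) - exp (s/2))^2 <= (3*(-(s/2)))^2) by (apply pow_incr; lra). nra.
Qed.

Lemma Rabs_mult_le x y X Y : Rabs x <= X -> Rabs y <= Y -> Rabs (x*y) <= X*Y.
Proof.
  intros h1 h2. rewrite Rabs_mult. apply Rmult_le_compat; auto; apply Rabs_pos.
Qed.

(* [expm1_div q x = (exp (q x) - 1) / q] (and [x] when [q = 0]) is the solution of
   [u' = 1 + q u], [u(0) = 0]: every arc of the u-component is a multiple of it. *)
Definition expm1_div (q x : R) : R := if Req_EM_T q 0 then x else (exp (q*x) - 1)/q.

Lemma expm1_div_deriv q x : derivable_pt_lim (expm1_div q) x (exp (q*x)).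
Proof.
  apply is_derive_Reals. unfold expm1_div; destruct (Req_EM_T q 0) as [->|Hq].
  - rewrite Rmult_0_l, exp_0. auto_derive; auto.
  - auto_derive; auto. field. auto.
Qed.

Lemma expm1_div_cont q x : continuity_pt (expm1_div q) x.
Proof. apply derivable_continuous_pt. exists (exp (q*x)). apply expm1_div_deriv. Qed.

Lemma expm1_div_0 q : expm1_div q 0 = 0.
Proof. unfold expm1_div; destruct (Req_EM_T q 0). auto. rewrite Rmult_0_r, exp_0. field; auto. Qed.

Lemma exp_expm1_div q x : exp (q * x) = 1 + q * expm1_div q x.
Proof. unfold expm1_div. destruct (Req_EM_T q 0) as [->|h]. rewrite !Rmult_0_l, exp_0. ring. field. auto. Qed.

Lemma expm1_div_lt q x y : x < y -> expm1_div q x < expm1_div q y.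
Proof.
  intros H. unfold expm1_div; destruct (Req_EM_T q 0) as [->|Hq]; auto.
  destruct (Rlt_dec 0 q).
  - assert (exp (q*x) < exp (q*y)) by (apply exp_increasing; nra).
    apply Rmult_lt_compat_r; [apply Rinv_0_lt_compat; lra| lra].
  - assert (q < 0) by lra.
    assert (exp (q*y) < exp (q*x)) by (apply exp_increasing; nra).
    assert (0 < (exp (q*x) - exp (q*y)) * / (-q)).
    { apply Rmult_lt_0_compat. lra. apply Rinv_0_lt_compat; lra. }
    apply Rlt_0_minus. replace ((exp (q * y) - 1) / q - (exp (q * x) - 1) / q) with
      ((exp (q*x) - exp (q*y)) * / (-q)) by (field; lra). lra.
Qed.

Lemma expm1_div_le q x y : x <= y -> expm1_div q x <= expm1_div q y.
Proof. intros [H|H]. left; apply expm1_div_lt; auto. subst; lra. Qed.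

Lemma expm1_div_lt_inv q x y : expm1_div q x < expm1_div q y -> x < y.
Proof. intros H. destruct (Rlt_dec x y); auto. assert (expm1_div q y <= expm1_div q x)
  by (apply expm1_div_le; lra). lra. Qed.

Lemma expm1_div_inj q x y : expm1_div q x = expm1_div q y -> x = y.
Proof. intros H. destruct (Rtotal_order x y) as [h|[h|h]]; auto.
  apply (expm1_div_lt q) in h; lra. apply (expm1_div_lt q) in h; lra. Qed.

Lemma expm1_div_pos q x : 0 < x -> 0 < expm1_div q x.
Proof. intros. rewrite <- (expm1_div_0 q). apply expm1_div_lt; auto. Qed.

Lemma expm1_div_neg q x : x < 0 -> expm1_div q x < 0.
Proof. intros. rewrite <- (expm1_div_0 q). apply expm1_div_lt; auto. Qed.

Lemma expm1_div_mvt q x y : x < y -> exists xi, x < xi < y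
  /\ expm1_div q y - expm1_div q x = (y - x) * exp (q * xi).
Proof.
  intros H. destruct (MVT_cor2 (expm1_div q) (fun t => exp (q*t)) x y H) as [c [Hc1 Hc2]].
  intros; apply expm1_div_deriv. exists c; split; auto. rewrite Hc1; ring.
Qed.

Lemma expm1_div_expand q x : Rabs (q * x) <= 2 ->
  exists th, 0 <= th <= 1 /\ expm1_div q x = x * exp (q * x / 2 + th * (q * x)^2 / 2).
Proof.
  intros H. unfold expm1_div. destruct (Req_EM_T q 0) as [->|Hq].
  { exists 0. split. lra. replace (exp _) with 1. ring. rewrite <- exp_0; f_equal; field. }
  destruct (Req_EM_T x 0) as [->|Hx].
  { exists 0. split. lra. rewrite Rmult_0_r, exp_0. field. auto. }
  set (t := q * x). assert (Ht : t <> 0) by (unfold t; intro h; apply Rmult_integral in h; tauto).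
  set (s := t / 2). set (R0 := (exp s - exp (-s)) / (2 * s)).
  assert (Hs : Rabs s <= 1) by (unfold s; unfold Rdiv; rewrite Rabs_mult, Rabs_inv, (Rabs_right 2)
    by lra; fold t in H; lra).
  assert (HsZ : s <> 0) by (unfold s; lra).
  assert (HR : 1 <= R0 <= 1 + 9/8 * s^2).
  { unfold R0. assert (hc := cosh2_le s Hs). destruct (Rle_dec 0 s).
    - assert (0 < s) by lra. assert (h1 := sinh2_ge s r). assert (h2 := sinh2_le_cosh2 s r).
      split; apply Rmult_le_reg_r with (2*s); try lra;
      replace ((exp s - exp (-s)) / (2 * s) * (2 * s)) with (exp s - exp (-s)) by (field; lra); nra.
    - assert (0 < -s) by lra. assert (h1 := sinh2_ge (-s) ltac:(lra)).
      assert (h2 := sinh2_le_cosh2 (-s) ltac:(lra)).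
      rewrite Ropp_involutive in h1, h2.
      replace ((exp s - exp (-s)) / (2 * s)) with ((exp (-s) - exp s) / (2 * (-s))) by (field; lra).
      split; apply Rmult_le_reg_r with (2*(-s)); try lra;
      replace ((exp (-s) - exp s) / (2 * -s) * (2 * -s)) with (exp (-s) - exp s) by (field; lra); nra. }
  exists (ln R0 / (t^2/2)).
  assert (Hl0 : 0 <= ln R0).
  { destruct (Req_dec R0 1) as [->|]. rewrite ln_1; lra. left. rewrite <- ln_1. apply ln_increasing; lra. }
  assert (Hl1 : ln R0 <= R0 - 1).
  { replace R0 with (1 + (R0 - 1)) at 1 by ring. apply ln_1plus_le. lra. }
  assert (0 < t^2) by (apply pow2_gt_0; auto).
  split. split.
  - apply Rmult_le_pos; auto. apply Rlt_le, Rinv_0_lt_compat; lra.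
  - apply Rmult_le_reg_r with (t^2/2). lra. unfold Rdiv at 1. rewrite Rmult_assoc, Rinv_l by lra.
    unfold s in HR. nra.
  - replace (ln R0 / (t ^ 2 / 2) * t ^ 2 / 2) with (ln R0) by (field; auto).
    rewrite exp_plus, exp_ln by lra.
    assert (E1 : exp t = exp s * exp s) by (rewrite <- exp_plus; f_equal; unfold s; field).
    assert (E2 : exp s * exp (-s) = 1) by (rewrite <- exp_plus; replace (s + -s) with 0 by ring; apply exp_0).
    assert (E3 : 2 * s = q * x) by (unfold s, t; field).
    unfold R0. replace (t/2) with s by reflexivity. rewrite E1, E3.
    replace (exp s * exp s - 1) with (exp s * (exp s - exp (-s))) by (rewrite Rmult_minus_distr_l, E2; ring).
    field. split; auto.
Qed.

Lemma expm1_div_bounds q x : 0 < x -> Rabs q * x <= /2 ->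
  x / 2 <= expm1_div q x <= 2 * x /\ -2 * x <= expm1_div q (-x) <= - x / 2.
Proof.
  intros hx hq.
  destruct (expm1_div_mvt q 0 x hx) as [c [hc m]]. rewrite expm1_div_0 in m.
  destruct (expm1_div_mvt q (-x) 0 ltac:(lra)) as [c' [hc' m']]. rewrite expm1_div_0 in m'.
  assert (B1 : /2 <= exp (q*c) <= 2).
  { apply exp_small_bounds. rewrite Rabs_mult. apply Rle_trans with (Rabs q * x); auto.
    apply Rmult_le_compat_l. apply Rabs_pos. rewrite Rabs_right; lra. }
  assert (B2 : /2 <= exp (q*c') <= 2).
  { apply exp_small_bounds. rewrite Rabs_mult. apply Rle_trans with (Rabs q * x); auto.
    apply Rmult_le_compat_l. apply Rabs_pos. rewrite Rabs_left; lra. }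
  split; split; nra.
Qed.

Definition expm1_div_inv (q w : R) : R := if Req_EM_T q 0 then w else ln (1 + q * w) / q.

Lemma expm1_div_invK q w : 0 < 1 + q * w -> expm1_div q (expm1_div_inv q w) = w.
Proof.
  intros H. unfold expm1_div, expm1_div_inv. destruct (Req_EM_T q 0) as [->|Hq]; auto.
  replace (q * (ln (1 + q * w) / q)) with (ln (1 + q*w)) by (field; auto).
  rewrite exp_ln by auto. field. auto.
Qed.

Lemma expm1_div_inv_cont q w : 0 < 1 + q * w -> continuity_pt (expm1_div_inv q) w.
Proof.
  intros H. unfold expm1_div_inv. destruct (Req_EM_T q 0) as [->|Hq].
  - apply continuity_pt_id.
  - apply derivable_continuous_pt. exists (/ (1 + q*w)).
    apply is_derive_Reals. auto_derive. auto. field. split; auto; lra.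
Qed.

(** * Transit equations and monotonicity of the return map *)

Definition rate (a : nat -> R) (e : R) (j : nat) : R := e * a j.
Definition drift (b : nat -> R) (e : R) (j : nat) : R := su j + e * b j.

(* The arc of the quadrant-2 field leaving (0, Y) meets the negative u-axis at
   [drift b e 2 * expm1_div (rate a e 2) Y]; the arc of the quadrant-3 field reaching
   (0, -Z) leaves it at [drift b e 3 * expm1_div (rate a e 3) (-Z)]. *)
Definition left_transit a b e Y Z :=
  drift b e 2 * expm1_div (rate a e 2) Y = drift b e 3 * expm1_div (rate a e 3) (- Z).
Definition right_transit a b e Z Y :=
  drift b e 4 * expm1_div (rate a e 4) Z = drift b e 1 * expm1_div (rate a e 1) (- Y).

Definition a_sum (a : nat -> R) := a 1%nat + a 2%nat + a 3%nat + a 4%nat.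
Definition b_alt (b : nat -> R) := b 1%nat - b 2%nat - b 3%nat + b 4%nat.
Definition ab_norm (a b : nat -> R) :=
  1 + Rabs (a 1%nat) + Rabs (a 2%nat) + Rabs (a 3%nat) + Rabs (a 4%nat)
  + Rabs (b 1%nat) + Rabs (b 2%nat) + Rabs (b 3%nat) + Rabs (b 4%nat).

Lemma ab_norm_bounds a b : 1 <= ab_norm a b /\
  Rabs (a 1%nat) <= ab_norm a b /\ Rabs (a 2%nat) <= ab_norm a b /\ Rabs (a 3%nat) <= ab_norm a b
    /\ Rabs (a 4%nat) <= ab_norm a b /\
  Rabs (b 1%nat) <= ab_norm a b /\ Rabs (b 2%nat) <= ab_norm a b /\ Rabs (b 3%nat) <= ab_norm a b
    /\ Rabs (b 4%nat) <= ab_norm a b.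
Proof.
  unfold ab_norm. assert (h1 := Rabs_pos (a 1%nat)). assert (h2 := Rabs_pos (a 2%nat)).
  assert (h3 := Rabs_pos (a 3%nat)). assert (h4 := Rabs_pos (a 4%nat)).
  assert (h5 := Rabs_pos (b 1%nat)). assert (h6 := Rabs_pos (b 2%nat)).
  assert (h7 := Rabs_pos (b 3%nat)). assert (h8 := Rabs_pos (b 4%nat)). repeat split; lra.
Qed.

Lemma alpha_star_a_sum a b : a_sum a <> 0 -> alpha_star a b * a_sum a = -2 * b_alt b.
Proof. intros H. unfold alpha_star, a_sum, b_alt in *. field. auto. Qed.

Lemma b_alt_neq0 a b : a_sum a <> 0 -> 0 < alpha_star a b -> b_alt b <> 0.
Proof. intros H1 H2 H3. unfold alpha_star in H2. unfold b_alt in H3. rewrite H3 in H2.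
  replace (- (2 * 0) / (a 1%nat + a 2%nat + a 3%nat + a 4%nat)) with 0 in H2 by (field; auto). lra. Qed.

Lemma drift_signs a b e : Rabs e * ab_norm a b <= /2 ->
  drift b e 1 <= -/2 /\ drift b e 2 <= -/2 /\ /2 <= drift b e 3 /\ /2 <= drift b e 4 /\
  Rabs (e * b 1%nat) <= /2 /\ Rabs (e * b 2%nat) <= /2 /\ Rabs (e * b 3%nat) <= /2
    /\ Rabs (e * b 4%nat) <= /2.
Proof.
  intros H. destruct (ab_norm_bounds a b) as (h0 & _ & _ & _ & _ & h1 & h2 & h3 & h4).
  assert (G : forall B, Rabs B <= ab_norm a b -> Rabs (e * B) <= /2).
  { intros B hB. rewrite Rabs_mult. apply Rle_trans with (Rabs e * ab_norm a b); auto.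
    apply Rmult_le_compat_l; auto. apply Rabs_pos. }
  assert (k1 := G _ h1). assert (k2 := G _ h2). assert (k3 := G _ h3). assert (k4 := G _ h4).
  unfold drift, su. apply Rabs_le_between in k1, k2, k3, k4. repeat split; try lra;
    apply Rabs_le_between; lra.
Qed.

Lemma drift1 b e : drift b e 1 = -1 + e * b 1%nat. Proof. reflexivity. Qed.
Lemma drift2 b e : drift b e 2 = -1 + e * b 2%nat. Proof. reflexivity. Qed.
Lemma drift3 b e : drift b e 3 = 1 + e * b 3%nat. Proof. reflexivity. Qed.
Lemma drift4 b e : drift b e 4 = 1 + e * b 4%nat. Proof. reflexivity. Qed.

Lemma Rabs_sub_between x y z al de : Rabs (x - al) <= de -> Rabs (y - al) <= de -> x <= z <= y
  -> Rabs (z - al) <= de.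
Proof. intros h1 h2 h3. apply Rabs_le_between in h1, h2. apply Rabs_le_between. lra. Qed.

Lemma transit_monotone a b e Y1 Z1 W1 Y2 Z2 W2 : Rabs e * ab_norm a b <= /2 ->
  left_transit a b e Y1 Z1 -> right_transit a b e Z1 W1 -> left_transit a b e Y2 Z2
    -> right_transit a b e Z2 W2 -> Y1 < Y2 ->
  Z1 < Z2 /\ W1 < W2.
Proof.
  intros He h1 h2 h3 h4 hY. destruct (drift_signs a b e He) as (s1 & s2 & s3 & s4 & _).
  unfold left_transit, right_transit in *.
  assert (k1 := expm1_div_lt (rate a e 2) _ _ hY).
  assert (expm1_div (rate a e 3) (-Z2) < expm1_div (rate a e 3) (-Z1)).
  { apply Rmult_lt_reg_l with (drift b e 3). lra. rewrite <- h1, <- h3. apply Rmult_lt_gt_compat_neg_l; lra. }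
  apply expm1_div_lt_inv in H. split. lra.
  assert (k2 := expm1_div_lt (rate a e 4) Z1 Z2 ltac:(lra)).
  assert (expm1_div (rate a e 1) (-W2) < expm1_div (rate a e 1) (-W1)).
  { apply Ropp_lt_cancel. apply Rmult_lt_reg_l with (- drift b e 1). lra.
    replace (- drift b e 1 * - expm1_div (rate a e 1) (- W2))
      with (drift b e 1 * expm1_div (rate a e 1) (- W2)) by ring.
    replace (- drift b e 1 * - expm1_div (rate a e 1) (- W1))
      with (drift b e 1 * expm1_div (rate a e 1) (- W1)) by ring.
    rewrite <- h2, <- h4. apply Rmult_lt_compat_l; lra. }
  apply expm1_div_lt_inv in H0. lra.
Qed.

Lemma left_transit_unique a b e Y Z Z' : Rabs e * ab_norm a b <= /2 ->
  left_transit a b e Y Z -> left_transit a b e Y Z' -> Z = Z'.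
Proof.
  intros he E E'. destruct (drift_signs a b e he) as (_ & _ & p3 & _).
  unfold left_transit in *.
  assert (expm1_div (rate a e 3) (-Z) = expm1_div (rate a e 3) (-Z')).
  { apply Rmult_eq_reg_l with (drift b e 3). rewrite <- E, <- E'. auto. lra. }
  apply expm1_div_inj in H. lra.
Qed.

Lemma right_transit_unique a b e Z Y Y' : Rabs e * ab_norm a b <= /2 ->
  right_transit a b e Z Y -> right_transit a b e Z Y' -> Y = Y'.
Proof.
  intros he E E'. destruct (drift_signs a b e he) as (p1 & _).
  unfold right_transit in *.
  assert (expm1_div (rate a e 1) (-Y) = expm1_div (rate a e 1) (-Y')).
  { apply Rmult_eq_reg_l with (drift b e 1). rewrite <- E, <- E'. auto. lra. }
  apply expm1_div_inj in H. lra.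
Qed.

Lemma log_return_slope_estimate e be al de N A1 A2 A3 A4 B1 B2 B3 B4 x1 x2 x3 x4 :
  Rabs A1 <= N -> Rabs A2 <= N -> Rabs A3 <= N -> Rabs A4 <= N ->
  Rabs B1 <= N -> Rabs B2 <= N -> Rabs B3 <= N -> Rabs B4 <= N ->
  1 <= N -> Rabs e * N <= /2 ->
  be = B1 - B2 - B3 + B4 -> al * (A1 + A2 + A3 + A4) = -2 * be ->
  4 * N * de <= Rabs be / 4 -> 8 * Rabs e * N^2 <= Rabs be / 4 ->
  Rabs (x1 - al) <= de -> Rabs (x2 - al) <= de -> Rabs (x3 - al) <= de -> Rabs (x4 - al) <= de ->
  Rabs (ln (1 + - e * B2) + ln (1 + e * B4) - ln (1 + e * B3) - ln (1 + - e * B1)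
        + e * (A2 * x1 + A3 * x2 + A4 * x3 + A1 * x4) + e * be) <= Rabs e * Rabs be / 2.
Proof.
  intros hA1 hA2 hA3 hA4 hB1 hB2 hB3 hB4 hN he hbe hal hde hee h1 h2 h3 h4.
  assert (L : forall B, Rabs B <= N -> Rabs (ln (1 + e*B) - e*B) <= 2 * (Rabs e * N)^2).
  { intros B hB. assert (Rabs (e*B) <= Rabs e * N) by (rewrite Rabs_mult; apply Rmult_le_compat_l;
    auto; apply Rabs_pos).
    eapply Rle_trans. apply Rabs_ln_1plus_sub_le. lra.
    apply Rmult_le_compat_l. lra. rewrite <- (pow2_abs (e*B)) at 1. apply pow_incr. split; auto.
    apply Rabs_pos. }
  assert (L' : forall B, Rabs B <= N -> Rabs (ln (1 + - e*B) + e*B) <= 2 * (Rabs e * N)^2).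
  { intros B hB. replace (-e*B) with (e * (-B)) by ring. replace (e*B) with (- (e * -B)) by ring.
    apply L. rewrite Rabs_Ropp; auto. }
  assert (M : forall A x, Rabs A <= N -> Rabs (x - al) <= de -> Rabs (e * (A * (x - al)))
    <= Rabs e * (N * de)).
  { intros A x hA hx. rewrite Rabs_mult. apply Rmult_le_compat_l. apply Rabs_pos. apply Rabs_mult_le; auto. }
  assert (k1 := L' B2 hB2). assert (k2 := L B4 hB4). assert (k3 := L B3 hB3). assert (k4 := L' B1 hB1).
  assert (m1 := M A2 x1 hA2 h1). assert (m2 := M A3 x2 hA3 h2). assert (m3 := M A4 x3 hA4 h3).
  assert (m4 := M A1 x4 hA1 h4).
  set (err := ln (1 + - e * B2) + ln (1 + e * B4) - ln (1 + e * B3) - ln (1 + - e * B1)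
        + e * (A2 * x1 + A3 * x2 + A4 * x3 + A1 * x4) + e * be).
  assert (Herr : err = (ln (1 + - e * B2) + e*B2) + (ln (1 + e * B4) - e*B4) - (ln (1 + e * B3) - e*B3)
     - (ln (1 + - e * B1) + e * B1) + e * (A2 * (x1 - al)) + e * (A3 * (x2-al)) + e * (A4 * (x3-al))
       + e * (A1 * (x4 - al))).
  { unfold err. replace (e * (A2 * x1 + A3 * x2 + A4 * x3 + A1 * x4)) with
      (e * (A2 * (x1 - al)) + e * (A3 * (x2-al)) + e * (A4 * (x3-al)) + e * (A1 * (x4 - al))
        + e * (al * (A1+A2+A3+A4))) by ring.
    rewrite hal, hbe. ring. }
  rewrite Herr.
  assert (Hsq : 2 * (Rabs e * N)^2 <= Rabs e * (Rabs be / 16)).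
  { assert (0 <= Rabs e) by apply Rabs_pos. nra. }
  assert (Hde : Rabs e * (N * de) <= Rabs e * (Rabs be / 16)).
  { apply Rmult_le_compat_l. apply Rabs_pos. lra. }
  apply Rabs_le_between in k1, k2, k3, k4, m1, m2, m3, m4.
  apply Rabs_le_between. assert (0 <= Rabs e * Rabs be) by (apply Rmult_le_pos; apply Rabs_pos).
  split; lra.
Qed.

Definition monotone_return a b e al de (stab : bool) :=
  forall Y1 Z1 W1 Y2 Z2 W2,
   Rabs (Y1 - al) <= de -> Rabs (Z1 - al) <= de -> Rabs (W1 - al) <= de ->
   Rabs (Y2 - al) <= de -> Rabs (Z2 - al) <= de -> Rabs (W2 - al) <= de ->
   left_transit a b e Y1 Z1 -> right_transit a b e Z1 W1 ->
   left_transit a b e Y2 Z2 -> right_transit a b e Z2 W2 -> Y1 < Y2 ->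
   W1 < W2 /\ (if stab then W1 - Y1 < W2 - Y2 else W2 - Y2 < W1 - Y1).

(* Mean value theorem on each of the four transit arcs. *)
Lemma return_increment a b e Y1 Z1 W1 Y2 Z2 W2 : Rabs e * ab_norm a b <= /2 ->
  left_transit a b e Y1 Z1 -> right_transit a b e Z1 W1 ->
  left_transit a b e Y2 Z2 -> right_transit a b e Z2 W2 -> Y1 < Y2 ->
  exists x1 x2 x3 x4, Y1 < x1 < Y2 /\ Z1 < x2 < Z2 /\ Z1 < x3 < Z2 /\ W1 < x4 < W2 /\
    W2 - W1 = exp (ln (1 + - e * b 2%nat) + ln (1 + e * b 4%nat) - ln (1 + e * b 3%nat)
                   - ln (1 + - e * b 1%nat)
                   + e * (a 2%nat * x1 + a 3%nat * x2 + a 4%nat * x3 + a 1%nat * x4)) * (Y2 - Y1).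
Proof.
  intros He e1 e2 e3 e4 hY.
  destruct (transit_monotone a b e Y1 Z1 W1 Y2 Z2 W2 He e1 e2 e3 e4 hY) as [hZ hW].
  destruct (drift_signs a b e He) as (s1 & s2 & s3 & s4 & _).
  destruct (expm1_div_mvt (rate a e 2) Y1 Y2 hY) as [x1 [hx1 m1]].
  destruct (expm1_div_mvt (rate a e 3) (-Z2) (-Z1) ltac:(lra)) as [x2 [hx2 m2]].
  destruct (expm1_div_mvt (rate a e 4) Z1 Z2 hZ) as [x3 [hx3 m3]].
  destruct (expm1_div_mvt (rate a e 1) (-W2) (-W1) ltac:(lra)) as [x4 [hx4 m4]].
  exists x1, (-x2), x3, (-x4). do 4 (split; [lra|]).
  unfold left_transit, right_transit in *.
  set (E1 := exp (rate a e 2 * x1)) in *. set (E2 := exp (rate a e 3 * x2)) in *.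
  set (E3 := exp (rate a e 4 * x3)) in *. set (E4 := exp (rate a e 1 * x4)) in *.
  assert (E1p : 0 < E1) by apply exp_pos. assert (E2p : 0 < E2) by apply exp_pos.
  assert (E3p : 0 < E3) by apply exp_pos. assert (E4p : 0 < E4) by apply exp_pos.
  assert (eq1 : drift b e 2 * (Y2 - Y1) * E1 = - (drift b e 3 * (Z2 - Z1) * E2)).
  { replace (Z2 - Z1) with (-Z1 - - Z2) by ring. rewrite Rmult_assoc, <- m1, Rmult_assoc, <- m2. lra. }
  assert (eq2 : drift b e 4 * (Z2 - Z1) * E3 = - (drift b e 1 * (W2 - W1) * E4)).
  { replace (W2 - W1) with (-W1 - - W2) by ring. rewrite Rmult_assoc, <- m3, Rmult_assoc, <- m4. lra. }
  rewrite drift1, drift2, drift3, drift4 in *.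
  set (L := ln (1 + - e * b 2%nat) + ln (1 + e * b 4%nat) - ln (1 + e * b 3%nat) - ln (1 + - e * b 1%nat)
        + e * (a 2%nat * x1 + a 3%nat * (-x2) + a 4%nat * x3 + a 1%nat * (-x4))).
  assert (HexpL : exp L = ((1 + - e * b 2%nat) * (1 + e * b 4%nat) * E1 * E3)
                          / ((1 + e * b 3%nat) * (1 + - e * b 1%nat) * E2 * E4)).
  { unfold L, E1, E2, E3, E4, rate. unfold Rminus. rewrite !exp_plus, !exp_Ropp, !exp_ln by lra.
    replace (e * (a 2%nat * x1 + a 3%nat * - x2 + a 4%nat * x3 + a 1%nat * - x4)) with
      (e * a 2%nat * x1 + - (e * a 3%nat * x2) + e * a 4%nat * x3 + - (e * a 1%nat * x4)) by ring.
    rewrite !exp_plus, !exp_Ropp. field. repeat split; try lra; apply Rgt_not_eq, exp_pos. }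
  rewrite HexpL.
  assert (HZ : Z2 - Z1 = (1 + - e * b 2%nat) * (Y2 - Y1) * E1 / ((1 + e * b 3%nat) * E2)).
  { apply Rmult_eq_reg_r with ((1 + e * b 3%nat) * E2). 2: apply Rgt_not_eq; apply Rmult_lt_0_compat; lra.
    unfold Rdiv. rewrite Rmult_assoc, Rinv_l. 2: apply Rgt_not_eq; apply Rmult_lt_0_compat; lra. lra. }
  apply Rmult_eq_reg_r with ((1 + - e * b 1%nat) * E4). 2: apply Rgt_not_eq; apply Rmult_lt_0_compat; lra.
  replace ((W2 - W1) * ((1 + - e * b 1%nat) * E4)) with ((1 + e * b 4%nat) * (Z2 - Z1) * E3) by lra.
  rewrite HZ. field. repeat split; lra.
Qed.

(* The logarithm of the slope of the return map is [- e * b_alt b + O(e * de + e^2)], so for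
   small [e] its sign, hence the stability of the orbit, is that of [- e * b_alt b]. *)
Lemma return_map_monotone a b : a_sum a <> 0 -> 0 < alpha_star a b ->
  exists de e2, 0 < de /\ de <= alpha_star a b / 2 /\ 0 < e2 /\
  forall e, 0 < Rabs e < e2 -> exists stab, monotone_return a b e (alpha_star a b) de stab.
Proof.
  intros Hsa Hal.
  assert (Hbe : b_alt b <> 0) by (apply (b_alt_neq0 a b); auto).
  set (al := alpha_star a b) in *. set (be := b_alt b) in *.
  assert (Habe : 0 < Rabs be) by (apply Rabs_pos_lt; auto).
  destruct (ab_norm_bounds a b) as (hA & ha1 & ha2 & ha3 & ha4 & hb1 & hb2 & hb3 & hb4).
  set (A := ab_norm a b) in *.
  exists (Rmin (al/2) (Rabs be / (16*A))), (Rmin (/(2*A)) (Rabs be/(32*A^2))).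
  assert (0 < A^2) by (apply pow_lt; lra).
  split. apply Rmin_pos. lra. apply Rdiv_lt_0_compat; lra.
  split. apply Rmin_l. split. apply Rmin_pos. apply Rinv_0_lt_compat; lra. apply Rdiv_lt_0_compat; lra.
  intros e He. set (de := Rmin (al / 2) (Rabs be / (16 * A))).
  assert (He1 : Rabs e * A <= /2).
  { assert (Rabs e <= / (2*A)) by (eapply Rle_trans; [left; apply He| apply Rmin_l]).
    apply Rmult_le_compat_r with (r := A) in H0; [|lra].
    replace (/ (2 * A) * A) with (/2) in H0 by (field; lra). lra. }
  assert (He2 : 8 * Rabs e * A^2 <= Rabs be / 4).
  { assert (Rabs e <= Rabs be / (32*A^2)) by (eapply Rle_trans; [left; apply He| apply Rmin_r]).
    apply Rmult_le_compat_r with (r := 8 * A^2) in H0; [|lra].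
    replace (Rabs be / (32 * A ^ 2) * (8 * A ^ 2)) with (Rabs be / 4) in H0 by (field; lra). lra. }
  assert (Hde : 4 * A * de <= Rabs be / 4).
  { assert (de <= Rabs be / (16 * A)) by apply Rmin_r.
    apply Rmult_le_compat_l with (r := 4 * A) in H0; [|lra].
    replace (4 * A * (Rabs be / (16 * A))) with (Rabs be / 4) in H0 by (field; lra). lra. }
  exists (if Rlt_dec 0 (- e * be) then true else false).
  intros Y1 Z1 W1 Y2 Z2 W2 hY1 hZ1 hW1 hY2 hZ2 hW2 e1 e2 e3 e4 hY.
  destruct (transit_monotone a b e Y1 Z1 W1 Y2 Z2 W2 He1 e1 e2 e3 e4 hY) as [hZ hW].
  split; auto.
  destruct (return_increment a b e Y1 Z1 W1 Y2 Z2 W2 He1 e1 e2 e3 e4 hY)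
    as (x1 & x2 & x3 & x4 & hx1 & hx2 & hx3 & hx4 & HW).
  set (L := ln (1 + - e * b 2%nat) + ln (1 + e * b 4%nat) - ln (1 + e * b 3%nat) - ln (1 + - e * b 1%nat)
        + e * (a 2%nat * x1 + a 3%nat * x2 + a 4%nat * x3 + a 1%nat * x4)) in HW.
  assert (HL : Rabs (L + e * be) <= Rabs e * Rabs be / 2).
  { apply (log_return_slope_estimate e be al de A (a 1%nat) (a 2%nat) (a 3%nat) (a 4%nat)
      (b 1%nat) (b 2%nat) (b 3%nat) (b 4%nat)); auto.
    - apply alpha_star_a_sum; auto.
    - apply (Rabs_sub_between Y1 Y2); auto; lra.
    - apply (Rabs_sub_between Z1 Z2); auto; lra.
    - apply (Rabs_sub_between Z1 Z2); auto; lra.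
    - apply (Rabs_sub_between W1 W2); auto; lra. }
  apply Rabs_le_between in HL.
  assert (Hsgn : (W2 - Y2) - (W1 - Y1) = (exp L - 1) * (Y2 - Y1)) by lra.
  destruct (Rlt_dec 0 (- e * be)) as [hpos|hneg].
  - assert (Rabs e * Rabs be = - (e * be)) by (rewrite <- Rabs_mult; apply Rabs_left; lra).
    assert (1 < exp L) by (rewrite <- exp_0; apply exp_increasing; lra).
    assert (0 < (exp L - 1) * (Y2 - Y1)) by (apply Rmult_lt_0_compat; lra). lra.
  - assert (e * be <> 0).
    { apply Rmult_integral_contrapositive; split; auto. intros h. rewrite h, Rabs_R0 in He. lra. }
    assert (Rabs e * Rabs be = e * be) by (rewrite <- Rabs_mult; apply Rabs_right; lra).
    assert (exp L < 1) by (rewrite <- exp_0; apply exp_increasing; lra).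
    assert (0 < (1 - exp L) * (Y2 - Y1)) by (apply Rmult_lt_0_compat; lra). lra.
Qed.

(** * A fixed point of the return map near [alpha_star] *)

Lemma rate_bounds a b e : 
  Rabs (rate a e 1) <= Rabs e * ab_norm a b /\ Rabs (rate a e 2) <= Rabs e * ab_norm a b /\
  Rabs (rate a e 3) <= Rabs e * ab_norm a b /\ Rabs (rate a e 4) <= Rabs e * ab_norm a b /\
  Rabs (e * b 1%nat) <= Rabs e * ab_norm a b /\ Rabs (e * b 2%nat) <= Rabs e * ab_norm a b /\
  Rabs (e * b 3%nat) <= Rabs e * ab_norm a b /\ Rabs (e * b 4%nat) <= Rabs e * ab_norm a b.
Proof.
  destruct (ab_norm_bounds a b) as (h0 & h1 & h2 & h3 & h4 & h5 & h6 & h7 & h8).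
  unfold rate. rewrite !Rabs_mult.
  assert (0 <= Rabs e) by apply Rabs_pos.
  repeat split; apply Rmult_le_compat_l; auto.
Qed.

Lemma left_transit_apriori P Q qa qb Y Z : P <= -/2 -> -P <= 3/2 -> /2 <= Q -> 0 < Y ->
  Rabs qa * Y <= /2 -> Rabs qb * (12 * Y) <= /2 -> P * expm1_div qa Y = Q * expm1_div qb (-Z)
    -> 0 < Z <= 12 * Y.
Proof.
  intros h1 h2 h3 hY hqa hqb E.
  destruct (expm1_div_bounds qa Y hY hqa) as [[c1 c2] _].
  destruct (expm1_div_bounds qb (12*Y) ltac:(lra) hqb) as [_ [c3 c4]].
  assert (k : expm1_div qb (-Z) = P * expm1_div qa Y / Q) by (rewrite E; field; lra).
  assert (expm1_div qb (-Z) < 0).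
  { rewrite k. apply Rmult_lt_reg_r with Q. lra. replace (P * expm1_div qa Y / Q * Q)
    with (P * expm1_div qa Y) by (field; lra). nra. }
  rewrite <- (expm1_div_0 qb) in H. apply expm1_div_lt_inv in H.
  split. lra.
  destruct (Rle_dec Z (12*Y)) as [|n]; auto. exfalso.
  assert (expm1_div qb (-Z) < expm1_div qb (-(12*Y))) by (apply expm1_div_lt; lra).
  assert (-6 * Y <= expm1_div qb (-Z)).
  { rewrite k. apply Rmult_le_reg_r with Q. lra. replace (P * expm1_div qa Y / Q * Q)
    with (P * expm1_div qa Y) by (field; lra). nra. }
  lra.
Qed.

Lemma right_transit_apriori P4 P1 qc qd Y Z : /2 <= P4 -> P1 <= -/2 -> -P1 <= 3/2 -> 0 < Y ->
  Rabs qd * Y <= /2 -> Rabs qc * (12 * Y) <= /2 -> P4 * expm1_div qc Z = P1 * expm1_div qd (-Y)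
    -> 0 < Z <= 12 * Y.
Proof.
  intros h1 h2 h3 hY hqd hqc E.
  destruct (expm1_div_bounds qd Y hY hqd) as [_ [c1 c2]].
  destruct (expm1_div_bounds qc (12*Y) ltac:(lra) hqc) as [[c3 c4] _].
  assert (k : expm1_div qc Z = P1 * expm1_div qd (-Y) / P4) by (rewrite <- E; field; lra).
  assert (0 < expm1_div qc Z).
  { rewrite k. apply Rmult_lt_reg_r with P4. lra. replace (P1 * expm1_div qd (-Y) / P4 * P4)
    with (P1 * expm1_div qd (-Y)) by (field; lra). nra. }
  rewrite <- (expm1_div_0 qc) in H. apply expm1_div_lt_inv in H.
  split. lra.
  destruct (Rle_dec Z (12*Y)) as [|n]; auto. exfalso.
  assert (expm1_div qc (12*Y) < expm1_div qc Z) by (apply expm1_div_lt; lra).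
  assert (expm1_div qc Z <= 6 * Y).
  { rewrite k. apply Rmult_le_reg_r with P4. lra. replace (P1 * expm1_div qd (-Y) / P4 * P4)
    with (P1 * expm1_div qd (-Y)) by (field; lra). nra. }
  lra.
Qed.

Lemma left_transit_log P Q qa qb Y Z eta u v : P = -(1+u) -> Q = 1 + v -> Rabs u <= /2 -> Rabs v <= /2 ->
  0 < Y -> 0 < Z -> Rabs (qa*Y) <= eta -> Rabs (qb*Z) <= eta -> eta <= 1 ->
  P * expm1_div qa Y = Q * expm1_div qb (-Z) ->
  Rabs (ln Z - (ln (1+u) - ln (1+v) + ln Y + qa*Y/2 + qb*Z/2)) <= eta^2.
Proof.
  intros hP hQ hu hv hY hZ h1 h2 heta E.
  apply Rabs_le_between in hu, hv.
  destruct (expm1_div_expand qa Y ltac:(lra)) as [t1 [ht1 e1]].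
  destruct (expm1_div_expand qb (-Z) ltac:(rewrite Ropp_mult_distr_r_reverse, Rabs_Ropp; lra))
    as [t2 [ht2 e2]].
  set (A1 := qa * Y / 2 + t1 * (qa * Y) ^ 2 / 2) in *.
  set (A2 := qb * - Z / 2 + t2 * (qb * - Z) ^ 2 / 2) in *.
  assert (HZ : Z = exp (ln (1+u) - ln (1+v) + ln Y + (A1 - A2))).
  { unfold Rminus. rewrite !exp_plus, !exp_Ropp, !exp_ln by lra.
    rewrite e1, e2, hP, hQ in E.
    assert (0 < exp A2) by apply exp_pos.
    assert (K : Z * ((1+v)*exp A2) = (1+u)*(Y*exp A1)) by lra.
    apply Rmult_eq_reg_r with ((1+v) * exp A2). 2: apply Rgt_not_eq, Rmult_lt_0_compat; lra.
    rewrite K. field. lra. }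
  rewrite HZ at 1. rewrite ln_exp.
  unfold A1, A2.
  assert (0 <= (qa*Y)^2 <= eta^2).
  { split. apply pow2_ge_0. rewrite <- (pow2_abs (qa*Y)). apply pow_incr. split; auto. apply Rabs_pos. }
  assert (0 <= (qb*Z)^2 <= eta^2).
  { split. apply pow2_ge_0. rewrite <- (pow2_abs (qb*Z)). apply pow_incr. split; auto. apply Rabs_pos. }
  replace ((qb * - Z)^2) with ((qb*Z)^2) by ring.
  assert (0 <= t1 * (qa*Y)^2 <= eta^2) by (split; [apply Rmult_le_pos; lra| replace (eta^2)
    with (1 * eta^2) by ring; apply Rmult_le_compat; lra]).
  assert (0 <= t2 * (qb*Z)^2 <= eta^2) by (split; [apply Rmult_le_pos; lra| replace (eta^2)
    with (1 * eta^2) by ring; apply Rmult_le_compat; lra]).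
  apply Rabs_le_between. split; lra.
Qed.

Lemma right_transit_log P4 P1 qc qd Y Z eta u v : P4 = 1 + v -> P1 = -(1+u) -> Rabs u <= /2 -> Rabs v <= /2 ->
  0 < Y -> 0 < Z -> Rabs (qd*Y) <= eta -> Rabs (qc*Z) <= eta -> eta <= 1 ->
  P4 * expm1_div qc Z = P1 * expm1_div qd (-Y) ->
  Rabs (ln Z - (ln (1+u) - ln (1+v) + ln Y - qd*Y/2 - qc*Z/2)) <= eta^2.
Proof.
  intros hP hQ hu hv hY hZ h1 h2 heta E.
  apply Rabs_le_between in hu, hv.
  destruct (expm1_div_expand qc Z ltac:(lra)) as [t1 [ht1 e1]].
  destruct (expm1_div_expand qd (-Y) ltac:(rewrite Ropp_mult_distr_r_reverse, Rabs_Ropp; lra))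
    as [t2 [ht2 e2]].
  set (A1 := qc * Z / 2 + t1 * (qc * Z) ^ 2 / 2) in *.
  set (A2 := qd * - Y / 2 + t2 * (qd * - Y) ^ 2 / 2) in *.
  assert (HZ : Z = exp (ln (1+u) - ln (1+v) + ln Y + (A2 - A1))).
  { unfold Rminus. rewrite !exp_plus, !exp_Ropp, !exp_ln by lra.
    rewrite e1, e2, hP, hQ in E.
    assert (0 < exp A1) by apply exp_pos.
    assert (K : Z * ((1+v)*exp A1) = (1+u)*(Y*exp A2)) by lra.
    apply Rmult_eq_reg_r with ((1+v) * exp A1). 2: apply Rgt_not_eq, Rmult_lt_0_compat; lra.
    rewrite K. field. lra. }
  rewrite HZ at 1. rewrite ln_exp.
  unfold A1, A2.
  assert (0 <= (qd*Y)^2 <= eta^2).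
  { split. apply pow2_ge_0. rewrite <- (pow2_abs (qd*Y)). apply pow_incr. split; auto. apply Rabs_pos. }
  assert (0 <= (qc*Z)^2 <= eta^2).
  { split. apply pow2_ge_0. rewrite <- (pow2_abs (qc*Z)). apply pow_incr. split; auto. apply Rabs_pos. }
  replace ((qd * - Y)^2) with ((qd*Y)^2) by ring.
  assert (0 <= t1 * (qc*Z)^2 <= eta^2) by (split; [apply Rmult_le_pos; lra| replace (eta^2)
    with (1 * eta^2) by ring; apply Rmult_le_compat; lra]).
  assert (0 <= t2 * (qd*Y)^2 <= eta^2) by (split; [apply Rmult_le_pos; lra| replace (eta^2)
    with (1 * eta^2) by ring; apply Rmult_le_compat; lra]).
  apply Rabs_le_between. split; lra.
Qed.

Lemma Rabs_sub_le_ln_gap Y Z t : 0 < Y -> 0 < Z -> Rabs (ln Z - ln Y) <= t -> t <= /2 ->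
  Rabs (Z - Y) <= 2 * t * Y.
Proof.
  intros hY hZ h ht. assert (hx := Rabs_exp_sub1_le (ln Z - ln Y) ltac:(lra)).
  assert (exp (ln Z - ln Y) = Z * / Y) by (unfold Rminus; rewrite exp_plus, exp_Ropp, !exp_ln; lra).
  rewrite H in hx. replace (Z - Y) with (Y * (Z * / Y - 1)) by (field; lra).
  rewrite Rabs_mult, (Rabs_right Y) by lra. nra.
Qed.

Lemma transit_apriori a b e Y Z1 Z2 : 0 < Y -> Rabs e * ab_norm a b * (12 * Y) <= /2 ->
  Rabs e * ab_norm a b <= /2 ->
  left_transit a b e Y Z1 -> right_transit a b e Z2 Y -> 0 < Z1 <= 12 * Y /\ 0 < Z2 <= 12 * Y.
Proof.
  intros hY hq he E1 E2.
  destruct (drift_signs a b e he) as (s1 & s2 & s3 & s4 & c1 & c2 & _).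
  destruct (rate_bounds a b e) as (q1 & q2 & q3 & q4 & _).
  assert (Hq : forall q, Rabs q <= Rabs e * ab_norm a b -> Rabs q * Y <= /2 /\ Rabs q * (12 * Y) <= /2).
  { intros q hq'. assert (0 <= Rabs q) by apply Rabs_pos. split; nra. }
  destruct (Hq _ q1) as [q1a _]. destruct (Hq _ q2) as [q2a _].
  destruct (Hq _ q3) as [_ q3b]. destruct (Hq _ q4) as [_ q4b].
  apply Rabs_le_between in c1, c2. split.
  - apply (left_transit_apriori (drift b e 2) (drift b e 3) (rate a e 2) (rate a e 3)); auto;
      rewrite ?drift2; lra.
  - apply (right_transit_apriori (drift b e 4) (drift b e 1) (rate a e 4) (rate a e 1)); auto;
      rewrite ?drift1; lra.
Qed.

Lemma transit_log_gap a b e Y Z1 Z2 Lam :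
  0 < Y -> 12 * Y <= Lam -> 1 <= Lam -> Rabs e * ab_norm a b * Lam <= /12 ->
  left_transit a b e Y Z1 -> right_transit a b e Z2 Y ->
  (0 < Z1 <= 12 * Y /\ 0 < Z2 <= 12 * Y) /\
  (Rabs (Z1 - Y) <= 12 * (Rabs e * ab_norm a b * Lam) * Y /\ Rabs (Z2 - Y)
    <= 12 * (Rabs e * ab_norm a b * Lam) * Y) /\
  Rabs (ln Z1 - ln Z2 - e * (b_alt b + a_sum a * Y / 2)) <= 22 * (Rabs e * ab_norm a b * Lam)^2.
Proof.
  intros hY hL hL1 heta E1 E2.
  set (eta := Rabs e * ab_norm a b * Lam) in *.
  destruct (ab_norm_bounds a b) as (hA & _).
  assert (Heta0 : 0 <= eta) by (unfold eta; apply Rmult_le_pos; [apply Rmult_le_pos;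
    [apply Rabs_pos|lra]|lra]).
  assert (HeA : Rabs e * ab_norm a b <= eta) by (unfold eta; assert (0 <= Rabs e * ab_norm a b)
    by (apply Rmult_le_pos; [apply Rabs_pos|lra]); nra).
  assert (HeAY : Rabs e * ab_norm a b * (12 * Y) <= eta) by (unfold eta; apply Rmult_le_compat_l;
    [apply Rmult_le_pos; [apply Rabs_pos|lra]| lra]).
  assert (He12 : Rabs e * ab_norm a b <= /2) by lra.
  destruct (drift_signs a b e He12) as (s1 & s2 & s3 & s4 & _).
  destruct (rate_bounds a b e) as (q1 & q2 & q3 & q4 & c1 & c2 & c3 & c4).
  assert (Hq : forall q, Rabs q <= Rabs e * ab_norm a b -> Rabs q * Y <= eta / 12
    /\ Rabs q * (12 * Y) <= eta).
  { intros q hq. split; nra. }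
  destruct (Hq _ q1) as [q1a q1b]. destruct (Hq _ q2) as [q2a q2b].
  destruct (Hq _ q3) as [q3a q3b]. destruct (Hq _ q4) as [q4a q4b].
  assert (Z1b : 0 < Z1 <= 12 * Y /\ 0 < Z2 <= 12 * Y)
    by (apply (transit_apriori a b e); auto; lra).
  destruct Z1b as [Z1b Z2b].
  split. auto.
  assert (QY : forall q, Rabs q * Y <= eta/12 -> Rabs (q * Y) <= eta) by (intros q h;
    rewrite Rabs_mult, (Rabs_right Y) by lra; lra).
  assert (QZ : forall q Z, 0 < Z <= 12 * Y -> Rabs q * (12 * Y) <= eta -> Rabs (q * Z) <= eta).
  { intros q Z hZ h. rewrite Rabs_mult, (Rabs_right Z) by lra. assert (0 <= Rabs q) by apply Rabs_pos. nra. }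
  assert (L1 := left_transit_log (drift b e 2) (drift b e 3) (rate a e 2) (rate a e 3)
    Y Z1 eta (- (e * b 2%nat)) (e * b 3%nat)
     ltac:(rewrite drift2; ring) ltac:(rewrite drift3; ring) ltac:(rewrite Rabs_Ropp; lra)
       ltac:(lra) hY ltac:(lra)
     (QY _ q2a) (QZ _ _ Z1b q3b) ltac:(lra) E1).
  assert (L2 := right_transit_log (drift b e 4) (drift b e 1) (rate a e 4) (rate a e 1)
    Y Z2 eta (- (e * b 1%nat)) (e * b 4%nat)
     ltac:(rewrite drift4; ring) ltac:(rewrite drift1; ring) ltac:(rewrite Rabs_Ropp; lra)
       ltac:(lra) hY ltac:(lra)
     (QY _ q1a) (QZ _ _ Z2b q4b) ltac:(lra) E2).
  assert (eta <= /12) by auto.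
  destruct (ln_1plus_bounds (- (e * b 2%nat)) eta ltac:(rewrite Rabs_Ropp; lra) ltac:(lra)) as [l2a l2b].
  destruct (ln_1plus_bounds (e * b 3%nat) eta ltac:(lra) ltac:(lra)) as [l3a l3b].
  destruct (ln_1plus_bounds (- (e * b 1%nat)) eta ltac:(rewrite Rabs_Ropp; lra) ltac:(lra)) as [l1a l1b].
  destruct (ln_1plus_bounds (e * b 4%nat) eta ltac:(lra) ltac:(lra)) as [l4a l4b].
  assert (qY2 := QY _ q2a). assert (qY1 := QY _ q1a).
  assert (qZ3 := QZ _ _ Z1b q3b). assert (qZ4 := QZ _ _ Z2b q4b).
  assert (eta^2 <= eta) by nra.
  assert (dev : forall Z, 0 < Z -> Rabs (ln Z - ln Y) <= 6 * eta -> Rabs (Z - Y) <= 12 * eta * Y).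
  { intros Z hZ h. replace (12 * eta * Y) with (2 * (6 * eta) * Y) by ring.
    apply Rabs_sub_le_ln_gap; auto; lra. }
  apply Rabs_le_between in L1, L2, l2a, l2b, l3a, l3b, l1a, l1b, l4a, l4b, qY2, qY1, qZ3, qZ4.
  assert (dZ1 : Rabs (Z1 - Y) <= 12 * eta * Y) by (apply dev; [lra| apply Rabs_le_between; split; lra]).
  assert (dZ2 : Rabs (Z2 - Y) <= 12 * eta * Y) by (apply dev; [lra| apply Rabs_le_between; split; lra]).
  split. split; auto.
  assert (m3 : Rabs (rate a e 3 * (Z1 - Y)) <= eta^2).
  { eapply Rle_trans. apply Rabs_mult_le. apply q3. apply dZ1. nra. }
  assert (m4 : Rabs (rate a e 4 * (Z2 - Y)) <= eta^2).
  { eapply Rle_trans. apply Rabs_mult_le. apply q4. apply dZ2. nra. }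
  apply Rabs_le_between in m3, m4.
  assert (Hsum : e * (b_alt b + a_sum a * Y / 2) = (- (e * b 2%nat))
    - e * b 3%nat - (- (e * b 1%nat)) + e * b 4%nat
     + rate a e 2 * Y / 2 + rate a e 3 * Y / 2 + rate a e 1 * Y / 2 + rate a e 4 * Y / 2).
  { unfold b_alt, a_sum, rate. field. }
  rewrite Hsum. apply Rabs_le_between.
  unfold rate in *. split; nra.
Qed.

Lemma cont_scaled_expm1_div c d q : forall Y, continuity_pt (fun Y => c * expm1_div q Y / d) Y.
Proof.
  intros Y. unfold Rdiv.
  change (continuity_pt (mult_fct (mult_fct (fct_cte c) (expm1_div q)) (fct_cte (/d))) Y).
  apply continuity_pt_mult. apply continuity_pt_mult.
  apply continuity_pt_const; intros ? ?; reflexivity. apply expm1_div_cont.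
  apply continuity_pt_const; intros ? ?; reflexivity.
Qed.

Lemma cont_scaled_expm1_div_opp c d q : forall Y, continuity_pt (fun Y => c * expm1_div q (-Y) / d) Y.
Proof.
  intros Y. unfold Rdiv.
  change (continuity_pt (mult_fct (mult_fct (fct_cte c) (comp (expm1_div q) (opp_fct id))) (fct_cte (/d))) Y).
  apply continuity_pt_mult. apply continuity_pt_mult.
  apply continuity_pt_const; intros ? ?; reflexivity.
  apply continuity_pt_comp. apply continuity_pt_opp, continuity_pt_id. apply expm1_div_cont.
  apply continuity_pt_const; intros ? ?; reflexivity.
Qed.

Lemma sign_of_perturbed X m g s K : (s = 1 \/ s = -1) -> 0 < K -> g <> 0 -> s * g * m = 50 * K * Rabs g ->
  Rabs (X - m) <= 22 * K -> 0 < s * g * X.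
Proof.
  intros hs hK hg hm hX.
  assert (Rabs (s * g) = Rabs g) by (destruct hs; subst; rewrite Rabs_mult;
    [rewrite Rabs_R1| rewrite (Rabs_left (-1)) by lra]; ring).
  assert (Rabs (s * g * (X - m)) <= Rabs g * (22 * K)) by (rewrite Rabs_mult, H;
    apply Rmult_le_compat_l; auto; apply Rabs_pos).
  assert (0 < Rabs g) by (apply Rabs_pos_lt; auto).
  apply Rabs_le_between in H0.
  replace (s * g * X) with (s * g * m + s * g * (X - m)) by ring. rewrite hm. nra.
Qed.

Definition left_height a b e Y :=
  - expm1_div_inv (rate a e 3) (drift b e 2 * expm1_div (rate a e 2) Y / drift b e 3).
Definition right_height a b e Y :=
  expm1_div_inv (rate a e 4) (drift b e 1 * expm1_div (rate a e 1) (- Y) / drift b e 4).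

Lemma Rabs_ratio_le P Q E Y : Rabs P <= 3/2 -> /2 <= Q -> Rabs E <= 2 * Y -> Rabs (P * E / Q) <= 6 * Y.
Proof.
  intros hP hQ hE. unfold Rdiv. rewrite !Rabs_mult, Rabs_inv, (Rabs_right Q) by lra.
  apply Rmult_le_reg_r with Q; [lra|]. rewrite Rmult_assoc, Rinv_l, Rmult_1_r by lra.
  assert (Rabs P * Rabs E <= 3/2 * (2 * Y)) by (apply Rmult_le_compat; auto; apply Rabs_pos).
  assert (0 <= Y) by (assert (h := Rabs_pos E); lra). nra.
Qed.

Lemma transit_heights a b e Y : 0 < Y -> Rabs e * ab_norm a b * (6 * Y) <= /2 ->
  Rabs e * ab_norm a b <= /2 ->
  0 < 1 + rate a e 3 * (drift b e 2 * expm1_div (rate a e 2) Y / drift b e 3) /\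
  0 < 1 + rate a e 4 * (drift b e 1 * expm1_div (rate a e 1) (- Y) / drift b e 4) /\
  left_transit a b e Y (left_height a b e Y) /\ right_transit a b e (right_height a b e Y) Y.
Proof.
  intros hY hq6 he.
  destruct (drift_signs a b e he) as (s1 & s2 & s3 & s4 & t1 & t2 & t3 & t4).
  destruct (rate_bounds a b e) as (q1 & q2 & q3 & q4 & _).
  assert (hq : forall q, Rabs q <= Rabs e * ab_norm a b -> Rabs q * Y <= /2 /\ Rabs q * (6 * Y) <= /2).
  { intros q hq'. assert (0 <= Rabs q) by apply Rabs_pos. split; nra. }
  destruct (hq _ q2) as [h2 _]. destruct (hq _ q1) as [h1 _].
  destruct (hq _ q3) as [_ h3]. destruct (hq _ q4) as [_ h4].
  destruct (expm1_div_bounds _ Y hY h2) as [[k1 k2] _].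
  destruct (expm1_div_bounds _ Y hY h1) as [_ [k3 k4]].
  set (w1 := drift b e 2 * expm1_div (rate a e 2) Y / drift b e 3).
  set (w2 := drift b e 1 * expm1_div (rate a e 1) (- Y) / drift b e 4).
  assert (P : forall j, Rabs (e * b j) <= /2 -> Rabs (drift b e j) <= 3/2).
  { intros j hj. unfold drift. apply Rabs_le_between in hj.
    destruct j as [|[|[|[|j]]]]; simpl; apply Rabs_le_between; lra. }
  assert (hw1 : Rabs w1 <= 6 * Y).
  { apply Rabs_ratio_le; auto. apply Rabs_le_between; lra. }
  assert (hw2 : Rabs w2 <= 6 * Y).
  { apply Rabs_ratio_le; auto. apply Rabs_le_between; lra. }
  assert (d1 : 0 < 1 + rate a e 3 * w1).
  { assert (Rabs (rate a e 3 * w1) <= /2)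
      by (rewrite Rabs_mult; assert (0 <= Rabs (rate a e 3)) by apply Rabs_pos; nra).
    apply Rabs_le_between in H. lra. }
  assert (d2 : 0 < 1 + rate a e 4 * w2).
  { assert (Rabs (rate a e 4 * w2) <= /2)
      by (rewrite Rabs_mult; assert (0 <= Rabs (rate a e 4)) by apply Rabs_pos; nra).
    apply Rabs_le_between in H. lra. }
  split; auto. split; auto. split.
  - unfold left_transit, left_height. fold w1. rewrite Ropp_involutive, expm1_div_invK by auto.
    unfold w1. field. lra.
  - unfold right_transit, right_height. fold w2. rewrite expm1_div_invK by auto.
    unfold w2. field. lra.
Qed.

Lemma height_gap_cont a b e Y : 0 < Y -> Rabs e * ab_norm a b * (6 * Y) <= /2 ->
  Rabs e * ab_norm a b <= /2 ->
  continuity_pt (fun Y => left_height a b e Y - right_height a b e Y) Y.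
Proof.
  intros hY hq he. destruct (transit_heights a b e Y hY hq he) as (d1 & d2 & _).
  change (continuity_pt (minus_fct
    (opp_fct (comp (expm1_div_inv (rate a e 3))
                   (fun Y => drift b e 2 * expm1_div (rate a e 2) Y / drift b e 3)))
    (comp (expm1_div_inv (rate a e 4))
          (fun Y => drift b e 1 * expm1_div (rate a e 1) (- Y) / drift b e 4))) Y).
  apply continuity_pt_minus; [apply continuity_pt_opp|];
    apply continuity_pt_comp; auto using cont_scaled_expm1_div, cont_scaled_expm1_div_opp,
    expm1_div_inv_cont.
Qed.

Definition height_window a b := 18 * alpha_star a b + 1.
Definition fixed_point_const a b :=
  100 * ab_norm a b ^ 2 * height_window a b ^ 2 / Rabs (a_sum a).

Lemma window_smallness a b e Y : 0 < alpha_star a b ->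
  Rabs e * ab_norm a b * height_window a b <= /12 -> 0 <= Y <= 3 * alpha_star a b / 2 ->
  Rabs e * ab_norm a b <= /2 /\ Rabs e * ab_norm a b * (6 * Y) <= /2.
Proof.
  intros Hal He hY. unfold height_window in He.
  assert (0 <= Rabs e * ab_norm a b)
    by (apply Rmult_le_pos; [apply Rabs_pos| destruct (ab_norm_bounds a b); lra]).
  assert (Rabs e * ab_norm a b * 1 <= Rabs e * ab_norm a b * (18 * alpha_star a b + 1))
    by (apply Rmult_le_compat_l; lra).
  assert (Rabs e * ab_norm a b * (6 * Y) <= Rabs e * ab_norm a b * (18 * alpha_star a b + 1))
    by (apply Rmult_le_compat_l; lra).
  lra.
Qed.

(* By [transit_log_gap] the log-ratio of the two heights is [e * a_sum a * (Y - alpha_star) / 2]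
   up to [O(e^2)]; at distance [fixed_point_const * |e|] from [alpha_star] the main term wins. *)
Lemma height_log_gap_sign a b e s : a_sum a <> 0 -> 0 < alpha_star a b -> (s = 1 \/ s = -1) ->
  0 < Rabs e -> Rabs e * ab_norm a b * height_window a b <= /12 ->
  fixed_point_const a b * Rabs e <= alpha_star a b / 2 ->
  0 < s * (e * a_sum a) *
    (ln (left_height a b e (alpha_star a b + s * fixed_point_const a b * Rabs e))
     - ln (right_height a b e (alpha_star a b + s * fixed_point_const a b * Rabs e))).
Proof.
  intros Hsa Hal hs Hepos He1 He2.
  assert (Hab := alpha_star_a_sum a b Hsa).
  set (al := alpha_star a b) in *. set (A := ab_norm a b) in *.
  set (Lam := height_window a b) in *. set (Cc := fixed_point_const a b) in *.
  set (S := Rabs (a_sum a)). assert (HS : 0 < S) by (apply Rabs_pos_lt; auto).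
  assert (hA : 1 <= A) by apply ab_norm_bounds.
  assert (HLam : Lam = 18 * al + 1) by reflexivity.
  assert (HCc : 0 <= Cc * Rabs e) by (apply Rmult_le_pos; [unfold Cc, fixed_point_const;
    apply Rmult_le_pos; [nra| left; apply Rinv_0_lt_compat; auto] | lra]).
  set (Y := al + s * Cc * Rabs e).
  assert (hY : al/2 <= Y <= 3*al/2) by (unfold Y; destruct hs; subst; lra).
  destruct (window_smallness a b e Y Hal He1 ltac:(fold al; lra)) as [HeA Hq6].
  destruct (transit_heights a b e Y ltac:(lra) Hq6 HeA) as (_ & _ & E1 & E2).
  destruct (transit_log_gap a b e Y _ _ Lam ltac:(lra) ltac:(lra) ltac:(lra) He1 E1 E2) as (_ & _ & D).
  fold A Lam in D. set (eta := Rabs e * A * Lam) in *.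
  assert (Hval : e * (b_alt b + a_sum a * Y / 2) = s * Cc * Rabs e * e * a_sum a / 2) by (unfold Y; nra).
  rewrite Hval in D.
  assert (Hes : Rabs (e * a_sum a) * Rabs e = e^2 * S) by (unfold S; rewrite Rabs_mult,
    <- (pow2_abs e); ring).
  assert (Hcc : Cc * S = 100 * A^2 * Lam^2) by (unfold Cc, fixed_point_const; fold A Lam S; field; lra).
  assert (Heta : eta^2 = e^2 * A^2 * Lam^2) by (unfold eta; rewrite <- (pow2_abs e); ring).
  assert (He0 : 0 < e^2) by (rewrite <- (pow2_abs e); apply pow_lt; lra).
  assert (Hg : e * a_sum a <> 0).
  { apply Rmult_integral_contrapositive; split; auto. intro h. rewrite h, Rabs_R0 in Hepos. lra. }
  apply (sign_of_perturbed _ (s * Cc * Rabs e * e * a_sum a / 2) (e * a_sum a) s (e^2 * A^2 * Lam^2)); auto.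
  - assert (0 < A^2 * Lam^2) by (apply Rmult_lt_0_compat; apply pow_lt; lra). nra.
  - assert (Hs2 : s * s = 1) by (destruct hs; subst; ring).
    assert (Hg2 : (e * a_sum a) * (e * a_sum a) = Rabs (e * a_sum a) * Rabs (e * a_sum a))
      by (rewrite <- Rabs_mult, Rabs_right; [auto| apply Rle_ge, Rle_0_sqr]).
    replace (s * (e * a_sum a) * (s * Cc * Rabs e * e * a_sum a / 2))
      with ((s*s) * Cc * (Rabs e * ((e * a_sum a) * (e * a_sum a))) / 2) by field.
    rewrite Hs2, Hg2.
    replace (1 * Cc * (Rabs e * (Rabs (e * a_sum a) * Rabs (e * a_sum a))) / 2) with
      (Rabs (e * a_sum a) * ((Rabs (e * a_sum a) * Rabs e) * Cc) / 2) by field.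
    rewrite Hes. replace (e ^ 2 * S * Cc) with (e^2 * (Cc * S)) by ring. rewrite Hcc. field.
  - rewrite Heta in D. exact D.
Qed.

Lemma IVT_opposite_signs f m p : m < p -> (forall x, m <= x <= p -> continuity_pt f x) ->
  f m * f p < 0 -> exists x, m <= x <= p /\ f x = 0.
Proof.
  intros hmp hc hs. destruct (Rtotal_order (f m) 0) as [hm|[hm|hm]].
  - assert (0 < f p) by nra.
    destruct (Ranalysis5.IVT_interv f m p) as [x [hx1 hx2]]; auto. now exists x.
  - rewrite hm, Rmult_0_l in hs. lra.
  - assert (f p < 0) by nra.
    destruct (Ranalysis5.IVT_interv (fun x => - f x) m p) as [x [hx1 hx2]]; try lra.
    + intros x hx. apply continuity_pt_opp with (f := f). auto.
    + exists x. split; auto. lra.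
Qed.

Lemma ln_sub_pos x y : 0 < x -> 0 < y -> 0 < ln x - ln y -> 0 < x - y.
Proof. intros hx hy h. assert (ln y < ln x) by lra. apply ln_lt_inv in H; auto. lra. Qed.

Lemma height_gap_root a b e : a_sum a <> 0 -> 0 < alpha_star a b -> 0 < Rabs e ->
  Rabs e * ab_norm a b * height_window a b <= /12 ->
  fixed_point_const a b * Rabs e <= alpha_star a b / 2 ->
  exists y, Rabs (y - alpha_star a b) <= fixed_point_const a b * Rabs e /\
    left_height a b e y = right_height a b e y.
Proof.
  intros Hsa Hal Hepos He1 He2.
  set (al := alpha_star a b) in *. set (A := ab_norm a b) in *.
  set (Lam := height_window a b) in *. set (Cc := fixed_point_const a b) in *.
  assert (hA : 1 <= A) by apply ab_norm_bounds.
  assert (HLam : Lam = 18 * al + 1) by reflexivity.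
  assert (HCc : 0 < Cc).
  { unfold Cc, fixed_point_const. apply Rdiv_lt_0_compat; [|apply Rabs_pos_lt; auto].
    fold A Lam. apply Rmult_lt_0_compat; [|apply pow_lt; lra].
    assert (0 < A^2) by (apply pow_lt; lra). lra. }
  assert (Hwin : forall Y, al/2 <= Y <= 3*al/2 -> 0 < Y /\ Rabs e * A * (6 * Y) <= /2 /\
     0 < left_height a b e Y /\ 0 < right_height a b e Y).
  { intros Y hY. destruct (window_smallness a b e Y Hal He1 ltac:(fold al; lra)) as [HeA Hq6].
    destruct (transit_heights a b e Y ltac:(lra) Hq6 HeA) as (_ & _ & E1 & E2).
    destruct (transit_log_gap a b e Y _ _ Lam ltac:(lra) ltac:(lra) ltac:(lra) He1 E1 E2)
      as ([[h1 _] [h2 _]] & _). repeat split; auto; lra. }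
  set (Yp := al + 1 * Cc * Rabs e). set (Ym := al + -1 * Cc * Rabs e).
  assert (HCe : 0 < Cc * Rabs e) by (apply Rmult_lt_0_compat; lra).
  destruct (Hwin Yp ltac:(unfold Yp; lra)) as (_ & _ & p1 & p2).
  destruct (Hwin Ym ltac:(unfold Ym; lra)) as (_ & _ & m1 & m2).
  assert (Sp := height_log_gap_sign a b e 1 Hsa Hal ltac:(auto) Hepos He1 He2).
  assert (Sm := height_log_gap_sign a b e (-1) Hsa Hal ltac:(auto) Hepos He1 He2).
  fold al Cc Yp in Sp. fold al Cc Ym in Sm.
  set (F := fun Y => left_height a b e Y - right_height a b e Y).
  assert (Hsgn : F Ym * F Yp < 0).
  { unfold F. set (g := e * a_sum a) in *.
    destruct (Rlt_dec 0 g) as [hg|hg].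
    - assert (hp := ln_sub_pos _ _ p1 p2 ltac:(nra)).
      assert (hm := ln_sub_pos _ _ m2 m1 ltac:(nra)). nra.
    - assert (g <> 0).
      { unfold g. apply Rmult_integral_contrapositive; split; auto.
        intro h. rewrite h, Rabs_R0 in Hepos. lra. }
      assert (hp := ln_sub_pos _ _ p2 p1 ltac:(nra)).
      assert (hm := ln_sub_pos _ _ m1 m2 ltac:(nra)). nra. }
  destruct (IVT_opposite_signs F Ym Yp ltac:(unfold Ym, Yp; lra)) as [y [hy Fy]]; auto.
  { intros x hx. destruct (Hwin x ltac:(unfold Ym, Yp in hx; lra)) as (hx0 & hx6 & _).
    apply height_gap_cont; auto. apply (window_smallness a b e x Hal He1). unfold Ym, Yp in hx.
    fold al; lra. }
  exists y. split.
  - apply Rabs_le_between. unfold Ym, Yp in hy. lra.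
  - unfold F in Fy. lra.
Qed.

Lemma transit_fixed_point a b : a_sum a <> 0 -> 0 < alpha_star a b ->
  exists e1 C, 0 < e1 /\ 0 < C /\ forall e, 0 < Rabs e < e1 ->
   exists y z, left_transit a b e y z /\ right_transit a b e z y /\ 0 < y /\ 0 < z /\
     Rabs (y - alpha_star a b) <= C * Rabs e /\ Rabs (z - alpha_star a b) <= C * Rabs e.
Proof.
  intros Hsa Hal.
  set (al := alpha_star a b) in *. set (A := ab_norm a b).
  set (Lam := height_window a b). set (Cc := fixed_point_const a b).
  assert (hA : 1 <= A) by apply ab_norm_bounds.
  assert (HLam : Lam = 18 * al + 1) by reflexivity.
  assert (HCc : 0 < Cc).
  { unfold Cc, fixed_point_const. apply Rdiv_lt_0_compat; [|apply Rabs_pos_lt; auto].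
    fold A Lam. apply Rmult_lt_0_compat; [|apply pow_lt; lra].
    assert (0 < A^2) by (apply pow_lt; lra). lra. }
  exists (Rmin (/(12*A*Lam)) (al/(2*Cc))), (Cc + 18 * A * Lam * al).
  split. { apply Rmin_pos. apply Rinv_0_lt_compat. nra. apply Rdiv_lt_0_compat; lra. }
  split. { nra. }
  intros e He.
  assert (He1 : Rabs e * A * Lam <= /12).
  { assert (Rabs e <= /(12*A*Lam)) by (eapply Rle_trans; [left; apply He| apply Rmin_l]).
    apply Rmult_le_compat_r with (r := 12 * A * Lam) in H; [|nra].
    rewrite Rinv_l in H by nra. lra. }
  assert (He2 : Cc * Rabs e <= al / 2).
  { assert (Rabs e <= al/(2*Cc)) by (eapply Rle_trans; [left; apply He| apply Rmin_r]).
    apply Rmult_le_compat_l with (r := Cc) in H; [|lra].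
    replace (Cc * (al / (2*Cc))) with (al/2) in H by (field; lra). lra. }
  destruct (height_gap_root a b e Hsa Hal ltac:(lra) He1 He2) as [y [hy Fy]].
  fold al Cc in hy. apply Rabs_le_between in hy.
  destruct (window_smallness a b e y Hal He1 ltac:(fold al; lra)) as [HeA Hq6].
  destruct (transit_heights a b e y ltac:(lra) Hq6 HeA) as (_ & _ & E1 & E2).
  rewrite <- Fy in E2.
  destruct (transit_log_gap a b e y _ _ Lam ltac:(lra) ltac:(lra) ltac:(lra) He1 E1 E2)
    as ([[z1 _] _] & [dz _] & _).
  exists y, (left_height a b e y). repeat split; auto; try lra.
  - apply Rabs_le_between. assert (0 <= 18 * A * Lam * al * Rabs e) by (apply Rmult_le_pos;
    [nra| apply Rabs_pos]). lra.
  - apply Rabs_le_between in dz. apply Rabs_le_between.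
    assert (P1 : 0 <= Rabs e * A * Lam) by (apply Rmult_le_pos; [apply Rmult_le_pos;
      [apply Rabs_pos|lra]|lra]).
    assert (Rabs e * A * Lam * y <= Rabs e * A * Lam * (3 * al / 2)) by (apply Rmult_le_compat_l; lra).
    fold A in dz.
    assert (12 * (Rabs e * A * Lam) * y <= 18 * A * Lam * al * Rabs e).
    { replace (18 * A * Lam * al * Rabs e) with (12 * (Rabs e * A * Lam * (3 * al / 2))) by field. lra. }
    lra.
Qed.

(** * Gluing and periodizing functions *)

Lemma continuity_pt_intro f x : (forall eps, 0 < eps -> exists d, 0 < d /\ forall y, Rabs (y - x)
  < d -> Rabs (f y - f x) < eps) -> continuity_pt f x.
Proof.
  intros H eps He. destruct (H eps He) as [d [hd hf]]. exists d. split; auto.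
  intros y [_ hy]. apply hf. exact hy.
Qed.

Lemma continuity_pt_elim f x : continuity_pt f x -> forall eps, 0 < eps -> exists d, 0 < d
  /\ forall y, Rabs (y - x) < d -> Rabs (f y - f x) < eps.
Proof.
  intros H eps He. destruct (H eps He) as [d [hd hf]]. exists d. split; auto.
  intros y hy. destruct (Req_dec x y) as [<-|ne]. unfold Rminus; rewrite Rplus_opp_r, Rabs_R0; auto.
  apply hf. split. split; [exact I| exact ne]. exact hy.
Qed.

Lemma continuity_pt_glue f F1 F2 a b c : a < b < c ->
  (forall s, a < s < b -> f s = F1 s) -> (forall s, b < s < c -> f s = F2 s) ->
  f b = F1 b -> F1 b = F2 b -> continuity_pt F1 b -> continuity_pt F2 b -> continuity_pt f b.
Proof.
  intros hb h1 h2 e1 e2 c1 c2. apply continuity_pt_intro. intros eps he.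
  destruct (continuity_pt_elim _ _ c1 eps he) as [d1 [hd1 k1]].
  destruct (continuity_pt_elim _ _ c2 eps he) as [d2 [hd2 k2]].
  exists (Rmin (Rmin d1 d2) (Rmin (b - a) (c - b))). split.
  repeat apply Rmin_pos; lra.
  intros y hy. assert (hy1 : Rabs (y - b) < d1) by (eapply Rlt_le_trans; [apply hy|];
    eapply Rle_trans; apply Rmin_l).
  assert (hy2 : Rabs (y - b) < d2) by (eapply Rlt_le_trans; [apply hy|]; eapply Rle_trans;
    [apply Rmin_l| apply Rmin_r]).
  assert (hy3 : Rabs (y - b) < b - a) by (eapply Rlt_le_trans; [apply hy|]; eapply Rle_trans;
    [apply Rmin_r| apply Rmin_l]).
  assert (hy4 : Rabs (y - b) < c - b) by (eapply Rlt_le_trans; [apply hy|]; eapply Rle_trans;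
    [apply Rmin_r| apply Rmin_r]).
  apply Rabs_def2 in hy3. apply Rabs_def2 in hy4.
  destruct (Rtotal_order y b) as [l|[->|g]].
  - rewrite h1 by lra. rewrite e1. apply k1; auto.
  - unfold Rminus. rewrite Rplus_opp_r, Rabs_R0. lra.
  - rewrite h2 by lra. rewrite e1, e2. apply k2; auto.
Qed.

Lemma continuity_pt_local f F a b x : a < x < b -> (forall s, a < s < b -> f s = F s)
  -> continuity_pt F x -> continuity_pt f x.
Proof.
  intros hx h c. apply (continuity_pt_locally_ext F f (Rmin (x - a) (b - x)) x).
  - apply Rmin_pos; lra.
  - intros y hy. unfold Rdist in hy.
    assert (Rabs (y - x) < x - a) by (eapply Rlt_le_trans; [apply hy| apply Rmin_l]).
    assert (Rabs (y - x) < b - x) by (eapply Rlt_le_trans; [apply hy| apply Rmin_r]).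
    apply Rabs_def2 in H, H0. symmetry; apply h; lra.
  - exact c.
Qed.

Lemma derivable_pt_lim_local f F a b x l : a < x < b -> (forall s, a < s < b -> f s = F s)
  -> derivable_pt_lim F x l -> derivable_pt_lim f x l.
Proof.
  intros hx h d. apply derivable_pt_lim_locally_ext with F a b; auto.
  intros; symmetry; auto.
Qed.

Lemma derivable_pt_lim_shift f c x l : derivable_pt_lim f (x - c) l
  -> derivable_pt_lim (fun s => f (s - c)) x l.
Proof.
  intros H. apply is_derive_Reals. apply is_derive_Reals in H.
  replace l with (1 * l) by ring.
  apply (is_derive_comp f (fun s => s - c)). auto. auto_derive; auto; try ring.
Qed.

Lemma continuity_pt_shift f c x : continuity_pt f (x - c) -> continuity_pt (fun s => f (s - c)) x.
Proof.
  intros H. apply continuity_pt_intro. intros eps he.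
  destruct (continuity_pt_elim _ _ H eps he) as [d [hd k]]. exists d; split; auto.
  intros y hy. apply k. replace (y - c - (x - c)) with (y - x) by ring. auto.
Qed.

Lemma Int_part_bounds x : IZR (Int_part x) <= x < IZR (Int_part x) + 1.
Proof.
  unfold Int_part. rewrite minus_IZR. destruct (archimed x). lra.
Qed.

Lemma Int_part_unique x m : IZR m <= x < IZR m + 1 -> Int_part x = m.
Proof.
  intros H. unfold Int_part. assert (h := up_tech x m ltac:(lra) ltac:(rewrite plus_IZR; simpl; lra)).
  rewrite <- h. ring.
Qed.

Definition period_base (T t : R) : R := T * IZR (Int_part (t / T)).
Definition periodize (T : R) (f : R -> R) (t : R) : R := f (t - period_base T t).

Lemma periodize_base T f t : periodize T f t = f (t - period_base T t).
Proof. reflexivity. Qed.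

Lemma period_base_range T t : 0 < T -> 0 <= t - period_base T t < T.
Proof.
  intros hT. unfold period_base. destruct (Int_part_bounds (t/T)) as [h1 h2]. split.
  - apply Rmult_le_compat_l with (r := T) in h1. 2: lra. replace (T * (t/T)) with t in h1 by (field;
    lra). lra.
  - apply Rmult_lt_compat_l with (r := T) in h2. 2: lra. replace (T * (t/T)) with t in h2 by (field;
    lra). lra.
Qed.

Lemma periodize_in T f t : 0 < T -> 0 <= t < T -> periodize T f t = f t.
Proof.
  intros hT ht. unfold periodize, period_base. rewrite (Int_part_unique (t/T) 0).
  simpl. f_equal; ring.
  simpl. split. apply Rmult_le_pos; [lra| left; apply Rinv_0_lt_compat; lra].
  apply Rmult_lt_reg_r with T. lra. unfold Rdiv. rewrite Rmult_assoc, Rinv_l by lra. lra.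
Qed.

Lemma periodize_plus_period T f t : 0 < T -> periodize T f (t + T) = periodize T f t.
Proof.
  intros hT. unfold periodize, period_base. rewrite (Int_part_unique ((t+T)/T) (Int_part (t/T) + 1)).
  rewrite plus_IZR. f_equal. simpl. ring.
  destruct (Int_part_bounds (t/T)). rewrite plus_IZR. simpl.
  replace ((t+T)/T) with (t/T + 1) by (field; lra). lra.
Qed.

Lemma periodize_plus_nat T f n x : 0 < T -> periodize T f (x + INR n * T) = periodize T f x.
Proof.
  intros hT. induction n. simpl. rewrite Rmult_0_l, Rplus_0_r. auto.
  rewrite S_INR. replace (x + (INR n + 1) * T) with ((x + INR n * T) + T) by ring.
  rewrite periodize_plus_period; auto.
Qed.

Lemma periodize_local T y f t : 0 < y < T -> (forall s, -y <= s < 0 -> f (s + T) = f s) ->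
  0 <= t - period_base T t < T /\ forall s, period_base T t - y < s < period_base T t + T
    -> periodize T f s = f (s - period_base T t).
Proof.
  intros hy hf. split. { apply period_base_range. lra. }
  unfold period_base. set (k := Int_part (t / T)).
  intros s hs. unfold periodize, period_base.
  destruct (Rle_dec (T * IZR k) s).
    + rewrite (Int_part_unique (s/T) k). auto.
      split.
      * apply Rmult_le_reg_r with T. lra. replace (s / T * T) with s by (field; lra). lra.
      * apply Rmult_lt_reg_r with T. lra. replace (s / T * T) with s by (field; lra). lra.
    + rewrite (Int_part_unique (s/T) (k - 1)).
      * rewrite minus_IZR. simpl. replace (s - T * (IZR k - 1)) with ((s - T * IZR k) + T) by ring.
        apply hf. lra.
      * rewrite minus_IZR. simpl. split.
        -- apply Rmult_le_reg_r with T. lra. replace (s / T * T) with s by (field; lra). lra.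
        -- apply Rmult_lt_reg_r with T. lra. replace (s / T * T) with s by (field; lra). lra.
Qed.

Lemma periodize_cont T y f t : 0 < y < T -> (forall s, -y <= s < 0 -> f (s + T) = f s) ->
  (forall s, 0 <= s < T -> continuity_pt f s) -> continuity_pt (periodize T f) t.
Proof.
  intros hy hf hc. destruct (periodize_local T y f t hy hf) as [hc1 hc2].
  set (c := period_base T t) in *.
  apply continuity_pt_local with (fun s => f (s - c)) (c - y) (c + T). lra. auto.
  apply continuity_pt_shift. apply hc. lra.
Qed.

Definition concat4 (y z : R) (FA FB FC FD : R -> R) (t : R) : R :=
  if Rlt_dec t 0 then FD (t + (2*y + 2*z)) else
  if Rle_dec t y then FA t else
  if Rle_dec t (y + z) then FB t else
  if Rle_dec t (y + 2*z) then FC t else FD t.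

Lemma concat4_A y z FA FB FC FD t : 0 < y -> 0 < z -> 0 <= t <= y -> concat4 y z FA FB FC FD t = FA t.
Proof. intros. unfold concat4. destruct (Rlt_dec t 0); [lra|]. destruct (Rle_dec t y); [auto|lra]. Qed.
Lemma concat4_B y z FA FB FC FD t : 0 < y -> 0 < z -> y < t <= y + z -> concat4 y z FA FB FC FD t = FB t.
Proof. intros. unfold concat4. destruct (Rlt_dec t 0); [lra|]. destruct (Rle_dec t y); [lra|].
  destruct (Rle_dec t (y+z)); [auto|lra]. Qed.
Lemma concat4_C y z FA FB FC FD t : 0 < y -> 0 < z -> y + z < t <= y + 2*z
  -> concat4 y z FA FB FC FD t = FC t.
Proof. intros. unfold concat4. destruct (Rlt_dec t 0); [lra|]. destruct (Rle_dec t y); [lra|].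
  destruct (Rle_dec t (y+z)); [lra|].
  destruct (Rle_dec t (y+2*z)); [auto|lra]. Qed.
Lemma concat4_D y z FA FB FC FD t : 0 < y -> 0 < z -> y + 2*z < t -> concat4 y z FA FB FC FD t = FD t.
Proof. intros. unfold concat4. destruct (Rlt_dec t 0); [lra|]. destruct (Rle_dec t y); [lra|].
  destruct (Rle_dec t (y+z)); [lra|].
  destruct (Rle_dec t (y+2*z)); [lra|auto]. Qed.
Lemma concat4_neg y z FA FB FC FD t : t < 0 -> concat4 y z FA FB FC FD t = FD (t + (2*y+2*z)).
Proof. intros. unfold concat4. destruct (Rlt_dec t 0); [auto|lra]. Qed.

Lemma concat4_shift y z FA FB FC FD : 0 < y -> 0 < z -> FC (y + 2*z) = FD (y + 2*z) ->
  forall s, -y <= s < 0 -> concat4 y z FA FB FC FD (s + (2*y+2*z)) = concat4 y z FA FB FC FD s.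
Proof.
  intros hy hz hCD s hs. rewrite (concat4_neg _ _ _ _ _ _ s) by lra.
  destruct (Req_dec s (-y)) as [->|ne].
  - rewrite concat4_C by lra. replace (- y + (2 * y + 2 * z)) with (y + 2*z) by ring. auto.
  - rewrite concat4_D by lra. auto.
Qed.

Lemma concat4_cont y z FA FB FC FD : 0 < y -> 0 < z ->
  FA y = FB y -> FB (y+z) = FC (y+z) -> FC (y + 2*z) = FD (y + 2*z) -> FD (2*y+2*z) = FA 0 ->
  (forall s, continuity_pt FA s) -> (forall s, continuity_pt FB s) ->
  (forall s, continuity_pt FC s) -> (forall s, continuity_pt FD s) ->
  forall s, 0 <= s < 2*y+2*z -> continuity_pt (concat4 y z FA FB FC FD) s.
Proof.
  intros hy hz e1 e2 e3 e4 cA cB cC cD s hs.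
  set (f := concat4 y z FA FB FC FD).
  destruct (Rtotal_order s 0) as [l|[->|g0]]. lra.
  - apply continuity_pt_glue with (fun t => FD (t + (2*y+2*z))) FA (-y) y. lra.
    intros; unfold f; apply concat4_neg; lra. intros; unfold f; apply concat4_A; lra.
    unfold f; rewrite concat4_A by lra. rewrite Rplus_0_l; auto. rewrite Rplus_0_l; auto.
    apply continuity_pt_comp with (f1 := fun t => t + (2*y+2*z)) (f2 := FD). 
    apply derivable_continuous_pt. apply derivable_pt_plus. apply derivable_pt_id.
    apply derivable_pt_const. apply cD.
    auto.
  - destruct (Rtotal_order s y) as [l|[->|g1]].
    + apply continuity_pt_local with FA 0 y. lra. intros; unfold f; apply concat4_A; lra. auto.
    + apply continuity_pt_glue with FA FB 0 (y+z). lra. intros; unfold f; apply concat4_A; lra.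
      intros; unfold f; apply concat4_B; lra.
      unfold f; apply concat4_A; lra. auto. auto. auto.
    + destruct (Rtotal_order s (y+z)) as [l|[->|g2]].
      * apply continuity_pt_local with FB y (y+z). lra. intros; unfold f; apply concat4_B; lra. auto.
      * apply continuity_pt_glue with FB FC y (y+2*z). lra. intros; unfold f; apply concat4_B; lra.
        intros; unfold f; apply concat4_C; lra.
        unfold f; apply concat4_B; lra. auto. auto. auto.
      * destruct (Rtotal_order s (y+2*z)) as [l|[->|g3]].
        -- apply continuity_pt_local with FC (y+z) (y+2*z). lra. intros; unfold f; apply concat4_C; lra. auto.
        -- apply continuity_pt_glue with FC FD (y+z) (2*y+2*z). lra. intros; unfold f;
          apply concat4_C; lra. intros; unfold f; apply concat4_D; lra.
           unfold f; apply concat4_C; lra. auto. auto. auto.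
        -- apply continuity_pt_local with FD (y+2*z) (2*y+2*z+1). lra. intros; unfold f;
          apply concat4_D; lra. auto.
Qed.

(** * The explicit periodic orbit *)

Definition loop_time (y z : R) := 2*y + 2*z.
(* In quadrant [j] the field reads [u' = drift + rate * u], [v' = sv j],
   [w' = -w + e (c_j u + d_j)]; [w_slope * u + w_offset] is a particular solution of the
   last equation and [K * exp (-s)] its homogeneous part. *)
Definition w_slope (a c : nat -> R) e j := e * c j / (1 + rate a e j).
Definition w_offset (a b c d : nat -> R) e j := e * d j - w_slope a c e j * drift b e j.
Definition u_arc (a b : nat -> R) e j c0 := fun s => drift b e j * expm1_div (rate a e j) (s - c0).
Definition w_arc (a b c d : nat -> R) e j c0 K :=
  fun s => w_slope a c e j * u_arc a b e j c0 s + w_offset a b c d e j + K * exp (-s).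

Lemma u_arc_deriv a b e j c0 s : derivable_pt_lim (u_arc a b e j c0) s (Xu a b e j (u_arc a b e j c0 s)).
Proof.
  unfold u_arc, Xu. apply is_derive_Reals.
  replace (su j + e * (a j * (drift b e j * expm1_div (rate a e j) (s - c0)) + b j))
    with (drift b e j * (1 * exp (rate a e j * (s - c0)))).
  2: { rewrite exp_expm1_div. unfold drift, rate. ring. }
  apply is_derive_scal. apply (is_derive_comp (expm1_div (rate a e j)) (fun t => t - c0)).
  apply is_derive_Reals, expm1_div_deriv. auto_derive; auto; ring.
Qed.

Lemma u_arc_cont a b e j c0 s : continuity_pt (u_arc a b e j c0) s.
Proof. apply derivable_continuous_pt. eexists. apply u_arc_deriv. Qed.

Lemma w_arc_deriv a b c d e j c0 K s : 1 + rate a e j <> 0 ->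
  derivable_pt_lim (w_arc a b c d e j c0 K) s (Xw c d e j (u_arc a b e j c0 s) (w_arc a b c d e j c0 K s)).
Proof.
  intros hq. unfold w_arc.
  assert (hu := u_arc_deriv a b e j c0 s).
  replace (Xw c d e j (u_arc a b e j c0 s) (w_slope a c e j * u_arc a b e j c0 s + w_offset a b c d
    e j + K * exp (- s)))
    with (w_slope a c e j * Xu a b e j (u_arc a b e j c0 s) + 0 + K * ((-1) * exp (-s))).
  2: { unfold Xw, Xu, w_offset, w_slope, drift, rate in *. field. unfold rate in hq. auto. }
  change (derivable_pt_lim (plus_fct (plus_fct (mult_real_fct (w_slope a c e j) (u_arc a b e j c0))
    (fct_cte (w_offset a b c d e j)))
     (mult_real_fct K (comp exp (opp_fct id)))) s (w_slope a c e j * Xu a b e j (u_arc a b e j c0 s)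
       + 0 + K * ((-1) * exp (-s)))).
  apply derivable_pt_lim_plus. apply derivable_pt_lim_plus. apply derivable_pt_lim_scal. auto.
  apply derivable_pt_lim_const. apply derivable_pt_lim_scal.
  replace ((-1) * exp (-s)) with (exp (opp_fct id s) * (-1)) by (unfold opp_fct, id; ring).
  apply derivable_pt_lim_comp. apply derivable_pt_lim_opp. apply derivable_pt_lim_id.
  apply derivable_pt_lim_exp.
Qed.

Lemma w_arc_cont a b c d e j c0 K s : 1 + rate a e j <> 0 -> continuity_pt (w_arc a b c d e j c0 K) s.
Proof. intros h. apply derivable_continuous_pt. eexists. apply w_arc_deriv; auto. Qed.

Lemma derivable_pt_lim_affine v0 sg s : derivable_pt_lim (fun t => v0 + sg * t) s sg.
Proof. apply is_derive_Reals. auto_derive; auto; ring. Qed.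

(* The orbit starts at [(0, y)] and runs through quadrants 2, 3, 4, 1 during the time
   intervals [[0, y]], [[y, y+z]], [[y+z, y+2z]], [[y+2z, 2y+2z]]. *)
Definition uA a b e (y z : R) := u_arc a b e 2 0.
Definition uB a b e y z := u_arc a b e 3 (y + z).
Definition uC a b e y z := u_arc a b e 4 (y + z).
Definition uD a b e y z := u_arc a b e 1 (loop_time y z).
Definition vA (y z : R) := fun s => y + (-1) * s.
Definition vC (y z : R) := fun s => - (y + 2*z) + 1 * s.
Definition u_neg_cross a b e y z := uA a b e y z y.
Definition u_pos_cross a b e y z := uC a b e y z (y + 2*z).
(* [J1], [J2], [J3] are the jumps of the particular solutions at the inner switching times;
   [KA] is the constant that makes [w] continuous and [loop_time]-periodic. *)
Definition J1 a b c d e y z := (w_slope a c e 2 * u_neg_cross a b e y z + w_offset a b c d e 2 -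
  w_slope a c e 3 * u_neg_cross a b e y z - w_offset a b c d e 3) * exp y.
Definition J2 a b c d e y z := (w_offset a b c d e 3 - w_offset a b c d e 4) * exp (y + z).
Definition J3 a b c d e y z := (w_slope a c e 4 * u_pos_cross a b e y z + w_offset a b c d e 4 -
  w_slope a c e 1 * u_pos_cross a b e y z - w_offset a b c d e 1) * exp (y + 2*z).
Definition KA a b c d e y z :=
  (w_offset a b c d e 1 - w_offset a b c d e 2
   + (J1 a b c d e y z + J2 a b c d e y z + J3 a b c d e y z) * exp (- loop_time y z))
  / (1 - exp (- loop_time y z)).
Definition KB a b c d e y z := KA a b c d e y z + J1 a b c d e y z.
Definition KC a b c d e y z := KB a b c d e y z + J2 a b c d e y z.
Definition KD a b c d e y z := KC a b c d e y z + J3 a b c d e y z.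
Definition wA a b c d e y z := w_arc a b c d e 2 0 (KA a b c d e y z).
Definition wB a b c d e y z := w_arc a b c d e 3 (y + z) (KB a b c d e y z).
Definition wC a b c d e y z := w_arc a b c d e 4 (y + z) (KC a b c d e y z).
Definition wD a b c d e y z := w_arc a b c d e 1 (loop_time y z) (KD a b c d e y z).

Definition u_loop a b e y z := concat4 y z (uA a b e y z) (uB a b e y z) (uC a b e y z) (uD a b e y z).
Definition v_loop y z := concat4 y z (vA y z) (vA y z) (vC y z) (vC y z).
Definition w_loop a b c d e y z := concat4 y z (wA a b c d e y z) (wB a b c d e y z)
  (wC a b c d e y z) (wD a b c d e y z).
Definition orbit_u a b e y z := periodize (loop_time y z) (u_loop a b e y z).
Definition orbit_v y z := periodize (loop_time y z) (v_loop y z).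
Definition orbit_w a b c d e y z := periodize (loop_time y z) (w_loop a b c d e y z).

Lemma u_arcs_match a b e y z : left_transit a b e y z -> right_transit a b e z y ->
  uA a b e y z y = uB a b e y z y /\ uB a b e y z (y+z) = uC a b e y z (y+z) /\
  uC a b e y z (y + 2*z) = uD a b e y z (y + 2*z) /\ uD a b e y z (2*y+2*z) = uA a b e y z 0 /\
  uB a b e y z (y+z) = 0 /\ uA a b e y z 0 = 0.
Proof.
  intros h1 h2. unfold uA, uB, uC, uD, u_arc, loop_time, left_transit, right_transit in *.
  replace (y - 0) with y by ring. replace (y - (y+z)) with (-z) by ring.
  replace (y + z - (y + z)) with 0 by ring. replace (y + 2*z - (y+z)) with z by ring.
  replace (y + 2*z - (2*y + 2*z)) with (-y) by ring. replace (2*y+2*z - (2*y+2*z)) with 0 by ring.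
  replace (0 - 0) with 0 by ring. rewrite !expm1_div_0. repeat split; auto; ring.
Qed.

Lemma v_arcs_match y z : vA y z (y + z) = vC y z (y + z) /\ vC y z (2*y+2*z) = vA y z 0.
Proof. unfold vA, vC. split; ring. Qed.

Lemma w_arcs_match a b c d e y z : left_transit a b e y z -> right_transit a b e z y -> 0 < y -> 0 < z ->
  wA a b c d e y z y = wB a b c d e y z y /\ wB a b c d e y z (y+z) = wC a b c d e y z (y+z) /\
  wC a b c d e y z (y + 2*z) = wD a b c d e y z (y + 2*z) /\ wD a b c d e y z (2*y+2*z) = wA a b c d e y z 0.
Proof.
  intros h1 h2 hy hz. destruct (u_arcs_match a b e y z h1 h2) as (m1 & m2 & m3 & m4 & m5 & m6).
  unfold wA, wB, wC, wD, w_arc.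
  assert (hT : 0 < loop_time y z) by (unfold loop_time; lra).
  assert (exp (- loop_time y z) < 1) by (rewrite <- exp_0; apply exp_increasing; lra).
  fold (uA a b e y z) (uB a b e y z) (uC a b e y z) (uD a b e y z).
  assert (Ey := exp_pos y). assert (Eyz := exp_pos (y + z)). assert (Eyzz := exp_pos (y + 2*z)).
  repeat split.
  - rewrite <- m1. unfold KB, J1, u_neg_cross. rewrite exp_Ropp. field. lra.
  - rewrite <- m2, m5. unfold KC, J2. rewrite exp_Ropp. field. lra.
  - rewrite <- m3. unfold KD, J3, u_pos_cross. rewrite exp_Ropp. field. lra.
  - rewrite m4, m6. unfold KD, KC, KB. replace (- 0) with 0 by ring. rewrite exp_0.
    replace (2*y+2*z) with (loop_time y z) by reflexivity. unfold KA. field. lra.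
Qed.

Lemma in_region_cases j u v : in_region j u v ->
  (j = 1%nat /\ 0 < u /\ 0 < v) \/ (j = 2%nat /\ u < 0 /\ 0 < v) \/ (j = 3%nat /\ u < 0 /\ v < 0)
    \/ (j = 4%nat /\ 0 < u /\ v < 0).
Proof. destruct j as [|[|[|[|[|j]]]]]; simpl; intuition. Qed.

Lemma derivable_pt_lim_shift_on (G F : R -> R) c lo hi t l : lo < t - c < hi ->
  (forall s, lo < s - c < hi -> G s = F (s - c)) -> derivable_pt_lim F (t - c) l -> derivable_pt_lim G t l.
Proof.
  intros ht hG hF. apply derivable_pt_lim_local with (fun s => F (s - c)) (c + lo) (c + hi). lra.
  intros s hs. apply hG. lra. apply derivable_pt_lim_shift. auto.
Qed.

Definition closing_heights a b e y z := 0 < y /\ 0 < z /\ left_transit a b e y z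
  /\ right_transit a b e z y /\ Rabs e * ab_norm a b <= /2.

Lemma one_plus_rate_neq0 a b e j : Rabs e * ab_norm a b <= /2
  -> (j = 1 \/ j = 2 \/ j = 3 \/ j = 4)%nat -> 1 + rate a e j <> 0.
Proof.
  intros h hj. destruct (rate_bounds a b e) as (q1 & q2 & q3 & q4 & _).
  apply Rabs_le_between in q1, q2, q3, q4.
  destruct hj as [ -> | [ -> | [ -> | -> ] ] ]; lra.
Qed.

Lemma arc_signs a b e y z : closing_heights a b e y z ->
  (forall s, 0 < s < y -> uA a b e y z s < 0 /\ 0 < vA y z s) /\
  (forall s, y < s < y + z -> uB a b e y z s < 0 /\ vA y z s < 0) /\
  (forall s, y + z < s < y + 2*z -> 0 < uC a b e y z s /\ vC y z s < 0) /\
  (forall s, y + 2*z < s < 2*y+2*z -> 0 < uD a b e y z s /\ 0 < vC y z s).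
Proof.
  intros (hy & hz & h1 & h2 & he). destruct (drift_signs a b e he) as (s1 & s2 & s3 & s4 & _).
  unfold uA, uB, uC, uD, u_arc, vA, vC, loop_time.
  split; [|split; [|split]]; intros s hs; split.
  - assert (0 < expm1_div (rate a e 2) (s - 0)) by (apply expm1_div_pos; lra). nra.
  - lra.
  - assert (expm1_div (rate a e 3) (s - (y+z)) < 0) by (apply expm1_div_neg; lra). nra.
  - lra.
  - assert (0 < expm1_div (rate a e 4) (s - (y+z))) by (apply expm1_div_pos; lra). nra.
  - lra.
  - assert (expm1_div (rate a e 1) (s - (2*y+2*z)) < 0) by (apply expm1_div_neg; lra). nra.
  - lra.
Qed.

Lemma orbit_local a b c d e y z t : closing_heights a b e y z ->
  0 <= t - period_base (loop_time y z) t < loop_time y z /\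
  forall s, period_base (loop_time y z) t - y < s < period_base (loop_time y z) t + loop_time y z ->
    orbit_u a b e y z s = u_loop a b e y z (s - period_base (loop_time y z) t) /\
    orbit_v y z s = v_loop y z (s - period_base (loop_time y z) t) /\
    orbit_w a b c d e y z s = w_loop a b c d e y z (s - period_base (loop_time y z) t).
Proof.
  intros H. destruct H as (hy & hz & h1 & h2 & he) eqn:EH.
  destruct (u_arcs_match a b e y z h1 h2) as (m1 & m2 & m3 & m4 & m5 & m6).
  destruct (w_arcs_match a b c d e y z h1 h2 hy hz) as (w1 & w2 & w3 & w4).
  assert (hT : 0 < y < loop_time y z) by (unfold loop_time; lra).
  destruct (periodize_local (loop_time y z) y (u_loop a b e y z) t hT) as [k1 k2].
  { intros s hs. apply concat4_shift; auto. }
  destruct (periodize_local (loop_time y z) y (v_loop y z) t hT) as [_ k3].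
  { intros s hs. apply concat4_shift; auto. }
  destruct (periodize_local (loop_time y z) y (w_loop a b c d e y z) t hT) as [_ k4].
  { intros s hs. apply concat4_shift; auto. }
  split; auto. intros s hs. split; [|split]; [apply k2 | apply k3 | apply k4]; auto.
Qed.

Lemma orbit_continuous a b c d e y z t : closing_heights a b e y z ->
  continuity_pt (orbit_u a b e y z) t /\ continuity_pt (orbit_v y z) t /\
  continuity_pt (orbit_w a b c d e y z) t.
Proof.
  intros H. pose proof H as (hy & hz & h1 & h2 & he).
  destruct (u_arcs_match a b e y z h1 h2) as (m1 & m2 & m3 & m4 & _).
  destruct (w_arcs_match a b c d e y z h1 h2 hy hz) as (w1 & w2 & w3 & w4).
  destruct (v_arcs_match y z) as (v1 & v2).
  assert (hT : 0 < y < loop_time y z) by (unfold loop_time; lra).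
  split; [|split]; apply periodize_cont with y; auto; intros s hs; try (apply concat4_shift; auto).
  - apply concat4_cont; auto; intros; apply u_arc_cont.
  - apply concat4_cont; auto; intros; apply derivable_continuous_pt; eexists; apply derivable_pt_lim_affine.
  - apply concat4_cont; auto; intros; apply w_arc_cont; apply (one_plus_rate_neq0 a b e); auto.
Qed.

Lemma orbit_crossings a b e y z t : closing_heights a b e y z ->
  0 <= t <= loop_time y z -> orbit_u a b e y z t * orbit_v y z t = 0 ->
  In t (0 :: y :: (y+z) :: (y + 2*z) :: loop_time y z :: nil).
Proof.
  intros H ht hz0. pose proof H as (hy & hz & _).
  destruct (arc_signs a b e y z H) as (sA & sB & sC & sD).
  destruct (Req_dec t (loop_time y z)) as [->|ne]. { simpl; tauto. }
  assert (ht' : 0 <= t < loop_time y z) by lra.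
  unfold orbit_u, orbit_v in hz0. rewrite !periodize_in in hz0 by lra.
  unfold u_loop, v_loop, loop_time in *. simpl.
  destruct (Rtotal_order t 0) as [l|[->|g0]]; [lra|tauto|].
  destruct (Rtotal_order t y) as [l|[->|g1]]; [|tauto|].
  { rewrite !concat4_A in hz0 by lra. destruct (sA t ltac:(lra)). nra. }
  destruct (Rtotal_order t (y+z)) as [l|[->|g2]]; [|tauto|].
  { rewrite !concat4_B in hz0 by lra. destruct (sB t ltac:(lra)). nra. }
  destruct (Rtotal_order t (y+2*z)) as [l|[->|g3]]; [|tauto|].
  { rewrite !concat4_C in hz0 by lra. destruct (sC t ltac:(lra)). nra. }
  rewrite !concat4_D in hz0 by lra. destruct (sD t ltac:(lra)). nra.
Qed.

Lemma orbit_deriv_on_arc a b c d e y z t j lo hi (U V W : R -> R) : closing_heights a b e y z ->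
  0 <= lo -> hi <= loop_time y z ->
  lo < t - period_base (loop_time y z) t < hi ->
  (forall s, lo < s < hi ->
     u_loop a b e y z s = U s /\ v_loop y z s = V s /\ w_loop a b c d e y z s = W s) ->
  (forall s, derivable_pt_lim U s (Xu a b e j (U s))) ->
  (forall s, derivable_pt_lim V s (Xv j)) ->
  (forall s, derivable_pt_lim W s (Xw c d e j (U s) (W s))) ->
  derivable_pt_lim (orbit_u a b e y z) t (Xu a b e j (orbit_u a b e y z t)) /\
  derivable_pt_lim (orbit_v y z) t (Xv j) /\
  derivable_pt_lim (orbit_w a b c d e y z) t
    (Xw c d e j (orbit_u a b e y z t) (orbit_w a b c d e y z t)).
Proof.
  intros H hlo hhi ht hUVW dU dV dW.
  destruct (orbit_local a b c d e y z t H) as [_ k].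
  set (cc := period_base (loop_time y z) t) in *.
  assert (loc : forall s, lo < s - cc < hi -> orbit_u a b e y z s = U (s - cc) /\
     orbit_v y z s = V (s - cc) /\ orbit_w a b c d e y z s = W (s - cc)).
  { intros s hs. destruct (k s ltac:(pose proof H as (hy & _); lra)) as (e1 & e2 & e3).
    destruct (hUVW (s - cc) hs) as (f1 & f2 & f3). rewrite e1, e2, e3. auto. }
  destruct (loc t ht) as (eU & _ & eW). rewrite eU, eW.
  split; [|split].
  - apply (derivable_pt_lim_shift_on _ U cc lo hi); auto. intros s hs. apply loc; auto.
  - apply (derivable_pt_lim_shift_on _ V cc lo hi); auto. intros s hs. apply loc; auto.
  - apply (derivable_pt_lim_shift_on _ W cc lo hi); auto. intros s hs. apply loc; auto.
Qed.

Lemma orbit_solves a b c d e y z t j : closing_heights a b e y z ->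
  in_region j (orbit_u a b e y z t) (orbit_v y z t) ->
  derivable_pt_lim (orbit_u a b e y z) t (Xu a b e j (orbit_u a b e y z t)) /\
  derivable_pt_lim (orbit_v y z) t (Xv j) /\
  derivable_pt_lim (orbit_w a b c d e y z) t
    (Xw c d e j (orbit_u a b e y z t) (orbit_w a b c d e y z t)).
Proof.
  intros H hj. pose proof H as (hy & hz & h1 & h2 & he).
  destruct (u_arcs_match a b e y z h1 h2) as (_ & _ & _ & _ & m5 & m6).
  destruct (arc_signs a b e y z H) as (sA & sB & sC & sD).
  assert (qn : forall j, (j = 1 \/ j = 2 \/ j = 3 \/ j = 4)%nat -> 1 + rate a e j <> 0)
    by (intros; apply (one_plus_rate_neq0 a b e); auto).
  destruct (orbit_local a b c d e y z t H) as [k2 k3].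
  set (cc := period_base (loop_time y z) t) in *.
  destruct (k3 t ltac:(lra)) as (eU & eV & _). rewrite eU, eV in hj.
  unfold u_loop, v_loop in hj. set (sg := t - cc) in *. unfold loop_time in k2.
  destruct (Rtotal_order sg 0) as [l|[E|g0]]. lra.
  { rewrite E, concat4_A, m6 in hj by lra. apply in_region_cases in hj. lra. }
  destruct (Rtotal_order sg y) as [l|[E|g1]].
  { rewrite !concat4_A in hj by lra. destruct (sA sg ltac:(lra)).
    apply in_region_cases in hj.
    destruct hj as [[_ [h _]]|[[-> _]|[[_ [_ h]]|[_ [h _]]]]]; try lra.
    apply (orbit_deriv_on_arc _ _ _ _ _ _ _ _ _ 0 y (uA a b e y z) (vA y z) (wA a b c d e y z));
      auto; try (change (t - period_base (loop_time y z) t) with sg; lra); try (unfold loop_time;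
        lra); [intros s hs; unfold u_loop, v_loop, w_loop; rewrite !concat4_A by lra; auto
      | intros; apply u_arc_deriv| intros; apply derivable_pt_lim_affine| intros; apply w_arc_deriv,
        qn; auto]. }
  { rewrite E, !concat4_A in hj by lra. apply in_region_cases in hj. unfold vA in hj. lra. }
  destruct (Rtotal_order sg (y+z)) as [l|[E|g2]].
  { rewrite !concat4_B in hj by lra. destruct (sB sg ltac:(lra)).
    apply in_region_cases in hj.
    destruct hj as [[_ [h _]]|[[_ [_ h]]|[[-> _]|[_ [h _]]]]]; try lra.
    apply (orbit_deriv_on_arc _ _ _ _ _ _ _ _ _ y (y+z) (uB a b e y z) (vA y z) (wB a b c d e y z));
      auto; try (change (t - period_base (loop_time y z) t) with sg; lra); try (unfold loop_time;
        lra); [intros s hs; unfold u_loop, v_loop, w_loop; rewrite !concat4_B by lra; auto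
      | intros; apply u_arc_deriv| intros; apply derivable_pt_lim_affine| intros; apply w_arc_deriv,
        qn; auto]. }
  { rewrite E, concat4_B, m5 in hj by lra. apply in_region_cases in hj. lra. }
  destruct (Rtotal_order sg (y+2*z)) as [l|[E|g3]].
  { rewrite !concat4_C in hj by lra. destruct (sC sg ltac:(lra)).
    apply in_region_cases in hj.
    destruct hj as [[_ [_ h]]|[[_ [h _]]|[[_ [h _]]|[-> _]]]]; try lra.
    apply (orbit_deriv_on_arc _ _ _ _ _ _ _ _ _ (y+z) (y+2*z) (uC a b e y z) (vC y z) (wC a b c d e y z));
      auto; try (change (t - period_base (loop_time y z) t) with sg; lra); try (unfold loop_time;
        lra); [intros s hs; unfold u_loop, v_loop, w_loop; rewrite !concat4_C by lra; auto
      | intros; apply u_arc_deriv| intros; apply derivable_pt_lim_affine| intros; apply w_arc_deriv,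
        qn; auto]. }
  { rewrite E, !concat4_C in hj by lra. apply in_region_cases in hj. unfold vC in hj. lra. }
  rewrite !concat4_D in hj by lra. destruct (sD sg ltac:(lra)).
  apply in_region_cases in hj.
  destruct hj as [[-> _]|[[_ [h _]]|[[_ [h _]]|[_ [_ h]]]]]; try lra.
  apply (orbit_deriv_on_arc _ _ _ _ _ _ _ _ _ (y+2*z) (2*y+2*z) (uD a b e y z) (vC y z) (wD a b c d e y z));
    auto; try (change (t - period_base (loop_time y z) t) with sg; lra); try (unfold loop_time;
      lra); [intros s hs; unfold u_loop, v_loop, w_loop; rewrite !concat4_D by lra; auto
    | intros; apply u_arc_deriv| intros; apply derivable_pt_lim_affine| intros; apply w_arc_deriv, qn; auto].
Qed.

Lemma orbit_periodic a b c d e y z : closing_heights a b e y z ->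
  periodic_orbit a b c d e (orbit_u a b e y z) (orbit_v y z) (orbit_w a b c d e y z).
Proof.
  intros H. pose proof H as (hy & hz & _).
  split. { intros t. apply orbit_continuous; auto. }
  exists (loop_time y z). split. { unfold loop_time; lra. }
  split. { intros t. unfold orbit_u, orbit_v, orbit_w.
  rewrite !periodize_plus_period by (unfold loop_time; lra). auto. }
  split.
  - exists (0 :: y :: (y+z) :: (y + 2*z) :: loop_time y z :: nil). intros t ht h0.
    apply (orbit_crossings a b e); auto.
  - intros t j hj. apply orbit_solves; auto.
Qed.

(** * Arcs of an arbitrary periodic orbit *)

Lemma null_derivative_const f a b : a < b -> (forall t, a < t < b -> derivable_pt_lim f t 0) ->
  (forall t, a <= t <= b -> continuity_pt f t) -> forall t, a <= t <= b -> f t = f a.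
Proof.
  intros hab hd hc t ht.
  set (pr := fun x (P : a < x < b) => exist (fun l => derivable_pt_abs f x l) 0 (hd x P) : derivable_pt f x).
  apply (null_derivative_loc f a b pr hc). intros x P. reflexivity. auto.
Qed.

Lemma deriv_expm1_div_shift q t0 t : derivable_pt_lim (fun s => expm1_div q (s - t0)) t (exp (q * (t - t0))).
Proof. apply derivable_pt_lim_shift. apply expm1_div_deriv. Qed.

Lemma deriv_exp_affine q t0 t : derivable_pt_lim (fun s => exp (q * (s - t0))) t (exp (q * (t - t0)) * q).
Proof. apply is_derive_Reals. auto_derive; auto; try (unfold Rminus; ring). Qed.

Lemma linear_ode_solution (f : R -> R) p q s s' t0 : s < s' ->
  (forall t, s < t < s' -> derivable_pt_lim f t (p + q * f t)) ->
  (forall t, s <= t <= s' -> continuity_pt f t) -> s <= t0 <= s' ->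
  forall t, s <= t <= s' -> f t = f t0 * exp (q * (t - t0)) + p * expm1_div q (t - t0).
Proof.
  intros hs hd hc ht0 t ht.
  set (F := fun t => f t0 * exp (q * (t - t0)) + p * expm1_div q (t - t0)).
  set (psi := fun t => (f t - F t) * exp (- q * t)).
  assert (HF : forall t, derivable_pt_lim F t (p + q * F t)).
  { intros x. unfold F.
    replace (p + q * (f t0 * exp (q * (x - t0)) + p * expm1_div q (x - t0)))
      with (f t0 * (exp (q * (x - t0)) * q) + p * exp (q * (x - t0)))
      by (rewrite exp_expm1_div; ring).
    change (derivable_pt_lim (plus_fct (mult_real_fct (f t0) (fun s => exp (q * (s - t0))))
      (mult_real_fct p (fun s => expm1_div q (s - t0)))) x
      (f t0 * (exp (q * (x - t0)) * q) + p * exp (q * (x - t0)))).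
    apply derivable_pt_lim_plus; apply derivable_pt_lim_scal.
    - apply deriv_exp_affine.
    - apply deriv_expm1_div_shift. }
  assert (Hpsi : forall x, s < x < s' -> derivable_pt_lim psi x 0).
  { intros x hx. unfold psi.
    assert (h1 := derivable_pt_lim_minus _ _ _ _ _ (hd x hx) (HF x)).
    assert (h2 : derivable_pt_lim (fun t => exp (- q * t)) x (exp (- q * x) * (- q))).
    { apply is_derive_Reals. auto_derive; auto; try (unfold Rminus; ring). }
    assert (h3 := derivable_pt_lim_mult _ _ _ _ _ h1 h2).
    replace 0 with ((p + q * f x - (p + q * F x)) * exp (- q * x) + (f x - F x) * (exp (- q * x)
      * - q)) by ring.
    apply derivable_pt_lim_ext with (f := mult_fct (minus_fct f F) (fun t => exp (- q * t))).
      intros; reflexivity. auto. }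
  assert (Hcpsi : forall x, s <= x <= s' -> continuity_pt psi x).
  { intros x hx. unfold psi. apply continuity_pt_mult. apply continuity_pt_minus. auto.
    apply derivable_continuous_pt. exists (p + q * F x). apply HF.
    apply derivable_continuous_pt. exists (exp (- q * x) * (-q)). apply is_derive_Reals.
      auto_derive; auto; try (unfold Rminus; ring). }
  assert (k1 := null_derivative_const psi s s' hs Hpsi Hcpsi t ht).
  assert (k2 := null_derivative_const psi s s' hs Hpsi Hcpsi t0 ht0).
  assert (psi t0 = 0) by (unfold psi, F; replace (t0 - t0) with 0 by ring; rewrite expm1_div_0,
    Rmult_0_r, exp_0; ring).
  assert (psi t = 0) by lra. unfold psi in H0.
  apply Rmult_integral in H0. destruct H0. unfold F in H0. lra. exfalso. assert (0 < exp (-q*t))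
    by apply exp_pos. lra.
Qed.

Lemma const_speed_solution (f : R -> R) sg s s' : s < s' ->
  (forall t, s < t < s' -> derivable_pt_lim f t sg) ->
  (forall t, s <= t <= s' -> continuity_pt f t) ->
  forall t, s <= t <= s' -> f t = f s + sg * (t - s).
Proof.
  intros hs hd hc t ht.
  set (psi := fun t => f t - sg * t).
  assert (Hpsi : forall x, s < x < s' -> derivable_pt_lim psi x 0).
  { intros x hx. unfold psi. replace 0 with (sg - sg * 1) by ring.
    apply derivable_pt_lim_minus with (f1 := f) (f2 := fun t => sg * t). auto.
    apply is_derive_Reals. auto_derive; auto. }
  assert (Hc : forall x, s <= x <= s' -> continuity_pt psi x).
  { intros x hx. unfold psi. apply continuity_pt_minus. auto. apply derivable_continuous_pt.
    exists sg. apply is_derive_Reals. auto_derive; auto; try (unfold Rminus; ring). }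
  assert (k := null_derivative_const psi s s' hs Hpsi Hc t ht). unfold psi in k. lra.
Qed.

Lemma w_difference_decay (f g : R -> R) s s' : s < s' ->
  (forall t, s < t < s' -> derivable_pt_lim (fun x => f x - g x) t (- (f t - g t))) ->
  (forall t, s <= t <= s' -> continuity_pt f t /\ continuity_pt g t) ->
  forall t, s <= t <= s' -> (f t - g t) * exp t = (f s - g s) * exp s.
Proof.
  intros hs hd hc t ht.
  set (psi := fun t => (f t - g t) * exp t).
  assert (Hpsi : forall x, s < x < s' -> derivable_pt_lim psi x 0).
  { intros x hx. unfold psi. replace 0 with (- (f x - g x) * exp x + (f x - g x) * exp x) by ring.
    apply derivable_pt_lim_mult with (f1 := fun x => f x - g x) (f2 := exp). auto.
    apply derivable_pt_lim_exp. }
  assert (Hc : forall x, s <= x <= s' -> continuity_pt psi x).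
  { intros x hx. unfold psi. destruct (hc x hx). apply continuity_pt_mult. apply continuity_pt_minus; auto.
    apply derivable_continuous_pt. exists (exp x). apply derivable_pt_lim_exp. }
  apply (null_derivative_const psi s s' hs Hpsi Hc t ht).
Qed.

Definition periodic_data a b c d e (hu hv hw : R -> R) Th L :=
  (forall t, continuity_pt hu t /\ continuity_pt hv t /\ continuity_pt hw t) /\ 0 < Th /\
  (forall t, hu (t + Th) = hu t /\ hv (t + Th) = hv t /\ hw (t + Th) = hw t) /\
  (forall t, 0 <= t <= Th -> hu t * hv t = 0 -> In t L) /\
  (forall t j, in_region j (hu t) (hv t) ->
       derivable_pt_lim hu t (Xu a b e j (hu t)) /\
       derivable_pt_lim hv t (Xv j) /\
       derivable_pt_lim hw t (Xw c d e j (hu t) (hw t))).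

Lemma periodic_orbit_data a b c d e hu hv hw : periodic_orbit a b c d e hu hv hw -> exists Th L,
  periodic_data a b c d e hu hv hw Th L.
Proof.
  intros (HC & Th & HT & HP & [L HL] & HD). exists Th, L. unfold periodic_data.
  split; [exact HC|]. split; [exact HT|]. split; [exact HP|]. split; [exact HL| exact HD].
Qed.

Lemma periodic_data_shift_nat a b c d e hu hv hw Th L : periodic_data a b c d e hu hv hw Th L ->
  forall n t, hu (t + INR n * Th) = hu t /\ hv (t + INR n * Th) = hv t /\ hw (t + INR n * Th) = hw t.
Proof.
  intros (HC & HT & HP & HL & HD) n. induction n; intros t.
  - simpl. rewrite Rmult_0_l, Rplus_0_r. auto.
  - rewrite S_INR. replace (t + (INR n + 1) * Th) with ((t + INR n * Th) + Th) by ring.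
    destruct (HP (t + INR n * Th)) as (e1 & e2 & e3). rewrite e1, e2, e3. apply IHn.
Qed.

Lemma periodic_data_shift_int a b c d e hu hv hw Th L : periodic_data a b c d e hu hv hw Th L ->
  forall (k : Z) t, hu (t + IZR k * Th) = hu t /\ hv (t + IZR k * Th) = hv t /\ hw (t + IZR k * Th) = hw t.
Proof.
  intros H k t. destruct k as [|p|p].
  - simpl. rewrite Rmult_0_l, Rplus_0_r. auto.
  - rewrite <- positive_nat_Z, <- INR_IZR_INZ. apply (periodic_data_shift_nat _ _ _ _ _ _ _ _ _ _ H).
  - assert (IZR (Z.neg p) = - INR (Pos.to_nat p)) by (rewrite <- Pos2Z.opp_pos, opp_IZR,
    <- positive_nat_Z, <- INR_IZR_INZ; auto).
    rewrite H0. destruct (periodic_data_shift_nat _ _ _ _ _ _ _ _ _ _ H (Pos.to_nat p)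
      (t + - INR (Pos.to_nat p) * Th)) as (e1 & e2 & e3).
    replace (t + - INR (Pos.to_nat p) * Th + INR (Pos.to_nat p) * Th) with t in e1, e2, e3 by ring. auto.
Qed.

Lemma list_min (l : list R) (P : R -> Prop) : (exists x, In x l /\ P x) ->
  exists m, In m l /\ P m /\ forall x, In x l -> P x -> m <= x.
Proof.
  induction l as [|a l IH]; intros [x [hx px]]. destruct hx.
  destruct (classic (exists x, In x l /\ P x)) as [E|NE].
  - destruct (IH E) as [m [hm [pm mm]]].
    destruct (classic (P a)) as [pa|npa].
    + destruct (Rle_dec a m).
      * exists a. split. left; auto. split; auto. intros y [<-|hy] py. lra. specialize (mm y hy py). lra.
      * exists m. split. right; auto. split; auto. intros y [<-|hy] py. lra. auto.
    + exists m. split. right; auto. split; auto. intros y [<-|hy] py. contradiction. auto.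
  - destruct hx as [E|hx].
    + exists a. split. left; auto. split. rewrite E; auto. intros y [E2|hy] py. rewrite E2; lra.
      exfalso; apply NE; exists y; auto.
    + exfalso; apply NE; exists x; auto.
Qed.

Lemma list_max (l : list R) (P : R -> Prop) : (exists x, In x l /\ P x) ->
  exists m, In m l /\ P m /\ forall x, In x l -> P x -> x <= m.
Proof.
  intros H. destruct (list_min (map Ropp l) (fun x => P (-x))) as [m [hm [pm mm]]].
  { destruct H as [x [hx px]]. exists (-x). split. apply in_map; auto. rewrite Ropp_involutive; auto. }
  exists (-m). apply in_map_iff in hm. destruct hm as [x0 [<- hx0]]. rewrite Ropp_involutive in *.
  split; auto. split; auto. intros x hx px. assert (h := mm (-x) (in_map _ _ _ hx)
    ltac:(rewrite Ropp_involutive; auto)). lra.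
Qed.

Lemma crossings_in_window a b c d e hu hv hw Th L : periodic_data a b c d e hu hv hw Th L ->
  forall s, exists l, forall t, s < t <= s + Th -> hu t * hv t = 0 -> In t l.
Proof.
  intros H s. pose proof H as (HC & HT & HP & HL & HD).
  exists (map (fun x => x + Th * IZR (Int_part ((s - x)/Th) + 1)) L).
  intros t ht hz. set (m := Int_part (t/Th)). set (t' := t - Th * IZR m).
  destruct (Int_part_bounds (t/Th)) as [f1 f2]. fold m in f1, f2.
  assert (t1 : 0 <= t' < Th).
  { unfold t'. split.
    - apply Rmult_le_compat_l with (r := Th) in f1. 2: lra. replace (Th * (t/Th))
      with t in f1 by (field; lra). lra.
    - apply Rmult_lt_compat_l with (r := Th) in f2. 2: lra. replace (Th * (t/Th))
      with t in f2 by (field; lra). lra. }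
  destruct (periodic_data_shift_int _ _ _ _ _ _ _ _ _ _ H (- m) t) as (e1 & e2 & _).
  rewrite opp_IZR in e1, e2. replace (t + - IZR m * Th) with t' in e1, e2 by (unfold t'; ring).
  assert (In t' L) by (apply HL; [lra| rewrite e1, e2; auto]).
  apply in_map_iff. exists t'. split; auto.
  rewrite (Int_part_unique ((s - t')/Th) (m - 1)). rewrite plus_IZR, minus_IZR. simpl. unfold t'. ring.
  rewrite minus_IZR. simpl. split.
  - apply Rmult_le_reg_r with Th. lra. replace ((s - t') / Th * Th) with (s - t') by (field; lra).
    unfold t'. lra.
  - apply Rmult_lt_reg_r with Th. lra. replace ((s - t') / Th * Th) with (s - t') by (field; lra).
    unfold t'. lra.
Qed.

Lemma next_crossing a b c d e hu hv hw Th L : periodic_data a b c d e hu hv hw Th L ->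
  (exists t0, hu t0 * hv t0 = 0) ->
  forall s, exists s', s < s' /\ hu s' * hv s' = 0 /\ forall t, s < t < s' -> hu t * hv t <> 0.
Proof.
  intros H [t0 h0] s. pose proof H as (HC & HT & HP & HL & HD).
  destruct (crossings_in_window _ _ _ _ _ _ _ _ _ _ H s) as [l hl].
  set (k := (Int_part ((s - t0)/Th) + 1)%Z). set (t1 := t0 + IZR k * Th).
  destruct (Int_part_bounds ((s - t0)/Th)) as [f1 f2].
  assert (ht1 : s < t1 <= s + Th).
  { unfold t1, k. rewrite plus_IZR. simpl.
    apply Rmult_le_compat_r with (r := Th) in f1. 2: lra. apply Rmult_lt_compat_r with (r := Th)
      in f2. 2: lra.
    replace ((s - t0) / Th * Th) with (s - t0) in f1, f2 by (field; lra). lra. }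
  assert (hz1 : hu t1 * hv t1 = 0).
  { destruct (periodic_data_shift_int _ _ _ _ _ _ _ _ _ _ H k t0) as (e1 & e2 & _). unfold t1.
    rewrite e1, e2. auto. }
  destruct (list_min l (fun x => s < x <= s + Th /\ hu x * hv x = 0)) as [m [hm [[pm1 pm2] mm]]].
  { exists t1. split; auto. }
  exists m. split. lra. split; auto. intros t ht hzt. assert (m <= t) by (apply mm; [apply hl; auto;
    lra| split; auto; lra]). lra.
Qed.

Lemma continuous_sign_const (f : R -> R) s s' : (forall t, continuity_pt f t) -> (forall t,
  s < t < s' -> f t <> 0) ->
  forall t1 t2, s < t1 < s' -> s < t2 < s' -> 0 < f t1 -> 0 < f t2.
Proof.
  intros hc hnz t1 t2 h1 h2 p1. destruct (Rlt_dec 0 (f t2)) as [|n]; auto. exfalso.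
  assert (f t2 < 0) by (assert (f t2 <> 0) by (apply hnz; auto); lra).
  destruct (Rtotal_order t1 t2) as [l|[E|g]].
  - destruct (Ranalysis5.IVT_interv (fun x => - f x) t1 t2) as [zz [hz1 hz2]]; auto.
    intros; apply continuity_pt_opp with (f := f); auto. lra. lra.
    apply (hnz zz). lra. lra.
  - subst. lra.
  - destruct (Ranalysis5.IVT_interv f t2 t1) as [zz [hz1 hz2]]; auto.
    apply (hnz zz). lra. auto.
Qed.

Lemma region_const a b c d e hu hv hw Th L : periodic_data a b c d e hu hv hw Th L ->
  forall s s', s < s' -> (forall t, s < t < s' -> hu t * hv t <> 0) ->
  exists j, forall t, s < t < s' -> in_region j (hu t) (hv t).
Proof.
  intros H s s' hs hnz. pose proof H as (HC & HT & HP & HL & HD).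
  assert (cu : forall t, continuity_pt hu t) by (intros; apply HC).
  assert (cv : forall t, continuity_pt hv t) by (intros; apply HC).
  assert (nu : forall t, s < t < s' -> hu t <> 0) by (intros t ht h; apply (hnz t ht); rewrite h; ring).
  assert (nv : forall t, s < t < s' -> hv t <> 0) by (intros t ht h; apply (hnz t ht); rewrite h; ring).
  assert (nu' : forall t, s < t < s' -> (fun x => - hu x) t <> 0) by (intros t ht h; apply (nu t ht); lra).
  assert (nv' : forall t, s < t < s' -> (fun x => - hv x) t <> 0) by (intros t ht h; apply (nv t ht); lra).
  assert (cu' : forall t, continuity_pt (fun x => - hu x) t) by (intros;
    apply continuity_pt_opp with (f := hu); auto).
  assert (cv' : forall t, continuity_pt (fun x => - hv x) t) by (intros;
    apply continuity_pt_opp with (f := hv); auto).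
  set (mid := (s + s') / 2). assert (hm : s < mid < s') by (unfold mid; lra).
  assert (um := nu mid hm). assert (vm := nv mid hm).
  destruct (Rlt_dec 0 (hu mid)) as [pu|pu]; destruct (Rlt_dec 0 (hv mid)) as [pv|pv].
  - exists 1%nat. intros t ht. simpl. split; [apply (continuous_sign_const hu s s' cu nu mid t)|
    apply (continuous_sign_const hv s s' cv nv mid t)]; auto.
  - exists 4%nat. intros t ht. simpl. split. apply (continuous_sign_const hu s s' cu nu mid t); auto.
    assert (0 < - hv t) by (apply (continuous_sign_const (fun x => - hv x) s s' cv' nv' mid t);
      auto; lra). lra.
  - exists 2%nat. intros t ht. simpl. split.
    assert (0 < - hu t) by (apply (continuous_sign_const (fun x => - hu x) s s' cu' nu' mid t);
      auto; lra). lra.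
    apply (continuous_sign_const hv s s' cv nv mid t); auto.
  - exists 3%nat. intros t ht. simpl. split.
    assert (0 < - hu t) by (apply (continuous_sign_const (fun x => - hu x) s s' cu' nu' mid t);
      auto; lra). lra.
    assert (0 < - hv t) by (apply (continuous_sign_const (fun x => - hv x) s s' cv' nv' mid t);
      auto; lra). lra.
Qed.

Lemma Xu_drift a b e j u : Xu a b e j u = drift b e j + rate a e j * u.
Proof. unfold Xu, drift, rate. ring. Qed.

Lemma arc_formulas a b c d e hu hv hw Th L j s s' : periodic_data a b c d e hu hv hw Th L -> s < s' ->
  (forall t, s < t < s' -> in_region j (hu t) (hv t)) ->
  (forall t, s <= t <= s' -> hv t = hv s + sv j * (t - s)) /\
  (forall t0 t, s <= t0 <= s' -> s <= t <= s' -> hu t = hu t0 * exp (rate a e j * (t - t0))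
    + drift b e j * expm1_div (rate a e j) (t - t0)).
Proof.
  intros H hs hr. pose proof H as (HC & HT & HP & HL & HD). split.
  - apply const_speed_solution; auto. intros t ht. destruct (HD t j (hr t ht)) as (_ & h & _). auto.
    intros; apply HC.
  - intros t0 t h0 ht. apply linear_ode_solution with (s := s) (s' := s'); auto.
    intros x hx. destruct (HD x j (hr x hx)) as (h & _). rewrite Xu_drift in h. auto. intros; apply HC.
Qed.

Lemma arc_after_crossing a b c d e hu hv hw Th L s : periodic_data a b c d e hu hv hw Th L
  -> hu s * hv s = 0 ->
  exists s' j, s < s' /\ hu s' * hv s' = 0 /\ (forall t, s < t < s' -> hu t * hv t <> 0) /\
    (forall t, s < t < s' -> in_region j (hu t) (hv t)) /\
    (forall t, s <= t <= s' -> hv t = hv s + sv j * (t - s)) /\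
    (forall t0 t, s <= t0 <= s' -> s <= t <= s' -> hu t = hu t0 * exp (rate a e j * (t - t0))
      + drift b e j * expm1_div (rate a e j) (t - t0)).
Proof.
  intros H hz. destruct (next_crossing _ _ _ _ _ _ _ _ _ _ H ltac:(exists s; auto) s) as [s' [h1 [h2 h3]]].
  destruct (region_const _ _ _ _ _ _ _ _ _ _ H s s' h1 h3) as [j hj].
  destruct (arc_formulas _ _ _ _ _ _ _ _ _ _ j s s' H h1 hj) as [f1 f2].
  exists s', j. repeat split; auto.
Qed.

Lemma in_region_index j u v : in_region j u v -> (j = 1 \/ j = 2 \/ j = 3 \/ j = 4)%nat.
Proof. destruct j as [|[|[|[|[|j]]]]]; simpl; intuition. Qed.

Lemma sv_values j : (j = 1 \/ j = 2 \/ j = 3 \/ j = 4)%nat ->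
  (j = 1%nat -> sv j = 1) /\ (j = 2%nat -> sv j = -1) /\ (j = 3%nat -> sv j = -1) /\ (j = 4%nat -> sv j = 1).
Proof. intros; repeat split; intros ->; reflexivity. Qed.

Lemma arc_from_pos_v a b c d e hu hv hw Th L s Y : periodic_data a b c d e hu hv hw Th L
  -> Rabs e * ab_norm a b <= /2 ->
  hu s = 0 -> hv s = Y -> 0 < Y ->
  (forall t, s < t < s + Y -> in_region 2 (hu t) (hv t)) /\
  (forall t, s <= t <= s + Y -> hu t = drift b e 2 * expm1_div (rate a e 2) (t - s) /\ hv t = Y - (t - s)).
Proof.
  intros H he hu0 hv0 hY. destruct (drift_signs a b e he) as (p1 & p2 & p3 & p4 & _).
  destruct (arc_after_crossing _ _ _ _ _ _ _ _ _ _ s H ltac:(rewrite hu0; ring))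
    as [s' [j (h1 & h2 & h3 & hj & fv & fu)]].
  assert (FU : forall t, s <= t <= s' -> hu t = drift b e j * expm1_div (rate a e j) (t - s)).
  { intros t ht. rewrite (fu s t) by lra. rewrite hu0. ring. }
  set (ts := s + Rmin Y (s' - s) / 2).
  assert (hts : s < ts < s' /\ ts - s < Y) by (unfold ts; assert (h := Rmin_l Y (s'-s));
    assert (h' := Rmin_r Y (s'-s));
    assert (0 < Rmin Y (s' - s)) by (apply Rmin_pos; lra); lra).
  assert (hr := hj ts ltac:(lra)). assert (hu1 := FU ts ltac:(lra)).
  assert (hv1 := fv ts ltac:(lra)). rewrite hv0 in hv1.
  assert (Epos : 0 < expm1_div (rate a e j) (ts - s)) by (apply expm1_div_pos; lra).
  assert (jv := in_region_index _ _ _ hr). destruct (sv_values j jv) as (sv1 & sv2 & sv3 & sv4).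
  apply in_region_cases in hr.
  assert (j = 2%nat).
  { destruct hr as [(-> & hh & _)|[(-> & _)|[(-> & _ & hh)|(-> & _ & hh)]]]; auto.
    - rewrite hu1 in hh. nra.
    - rewrite hv1, sv3 in hh by auto. lra.
    - rewrite hv1, sv4 in hh by auto. lra. }
  subst j. rewrite sv2 in fv by auto.
  assert (s' = s + Y).
  { assert (hu2 := FU s' ltac:(lra)). assert (hv2 := fv s' ltac:(lra)). rewrite hv0 in hv2.
    assert (0 < expm1_div (rate a e 2) (s' - s)) by (apply expm1_div_pos; lra).
    assert (hu s' <> 0) by (rewrite hu2; nra). apply Rmult_integral in h2. destruct h2. contradiction. lra. }
  subst s'. split. auto. intros t ht. split. apply FU; lra. rewrite (fv t ht), hv0. ring.
Qed.

Lemma arc_from_neg_v a b c d e hu hv hw Th L s Z : periodic_data a b c d e hu hv hw Th L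
  -> Rabs e * ab_norm a b <= /2 ->
  hu s = 0 -> hv s = - Z -> 0 < Z ->
  (forall t, s < t < s + Z -> in_region 4 (hu t) (hv t)) /\
  (forall t, s <= t <= s + Z -> hu t = drift b e 4 * expm1_div (rate a e 4) (t - s) /\ hv t = - Z + (t - s)).
Proof.
  intros H he hu0 hv0 hY. destruct (drift_signs a b e he) as (p1 & p2 & p3 & p4 & _).
  destruct (arc_after_crossing _ _ _ _ _ _ _ _ _ _ s H ltac:(rewrite hu0; ring))
    as [s' [j (h1 & h2 & h3 & hj & fv & fu)]].
  assert (FU : forall t, s <= t <= s' -> hu t = drift b e j * expm1_div (rate a e j) (t - s)).
  { intros t ht. rewrite (fu s t) by lra. rewrite hu0. ring. }
  set (ts := s + Rmin Z (s' - s) / 2).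
  assert (hts : s < ts < s' /\ ts - s < Z) by (unfold ts; assert (h := Rmin_l Z (s'-s));
    assert (h' := Rmin_r Z (s'-s));
    assert (0 < Rmin Z (s' - s)) by (apply Rmin_pos; lra); lra).
  assert (hr := hj ts ltac:(lra)). assert (hu1 := FU ts ltac:(lra)).
  assert (hv1 := fv ts ltac:(lra)). rewrite hv0 in hv1.
  assert (Epos : 0 < expm1_div (rate a e j) (ts - s)) by (apply expm1_div_pos; lra).
  assert (jv := in_region_index _ _ _ hr). destruct (sv_values j jv) as (sv1 & sv2 & sv3 & sv4).
  apply in_region_cases in hr.
  assert (j = 4%nat).
  { destruct hr as [(-> & _ & hh)|[(-> & _ & hh)|[(-> & hh & _)|(-> & _)]]]; auto.
    - rewrite hv1, sv1 in hh by auto. lra.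
    - rewrite hv1, sv2 in hh by auto. lra.
    - rewrite hu1 in hh. nra. }
  subst j. rewrite sv4 in fv by auto.
  assert (s' = s + Z).
  { assert (hu2 := FU s' ltac:(lra)). assert (hv2 := fv s' ltac:(lra)). rewrite hv0 in hv2.
    assert (0 < expm1_div (rate a e 4) (s' - s)) by (apply expm1_div_pos; lra).
    assert (hu s' <> 0) by (rewrite hu2; nra). apply Rmult_integral in h2. destruct h2. contradiction. lra. }
  subst s'. split. auto. intros t ht. split. apply FU; lra. rewrite (fv t ht), hv0. ring.
Qed.

Lemma arc_from_neg_u a b c d e hu hv hw Th L s m : periodic_data a b c d e hu hv hw Th L
  -> Rabs e * ab_norm a b <= /2 ->
  hu s = m -> hv s = 0 -> m < 0 ->
  exists Z, 0 < Z /\ m = drift b e 3 * expm1_div (rate a e 3) (- Z) /\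
  (forall t, s < t < s + Z -> in_region 3 (hu t) (hv t)) /\
  (forall t, s <= t <= s + Z -> hu t = drift b e 3 * expm1_div (rate a e 3) (t - (s + Z))
    /\ hv t = - (t - s)).
Proof.
  intros H he hu0 hv0 hm. destruct (drift_signs a b e he) as (p1 & p2 & p3 & p4 & _).
  pose proof H as (HC & _).
  destruct (arc_after_crossing _ _ _ _ _ _ _ _ _ _ s H ltac:(rewrite hv0; ring))
    as [s' [j (h1 & h2 & h3 & hj & fv & fu)]].
  destruct (continuity_pt_elim hu s (proj1 (HC s)) (-m/2) ltac:(lra)) as [dl [hdl kd]].
  set (ts := s + Rmin dl (s' - s) / 2).
  assert (hts : s < ts < s' /\ ts - s < dl) by (unfold ts; assert (h := Rmin_l dl (s'-s));
    assert (h' := Rmin_r dl (s'-s));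
    assert (0 < Rmin dl (s' - s)) by (apply Rmin_pos; lra); lra).
  assert (hu1 : hu ts < 0).
  { assert (k := kd ts ltac:(rewrite Rabs_right; lra)). rewrite hu0 in k. apply Rabs_def2 in k. lra. }
  assert (hr := hj ts ltac:(lra)). assert (hv1 := fv ts ltac:(lra)). rewrite hv0 in hv1.
  assert (jv := in_region_index _ _ _ hr). destruct (sv_values j jv) as (sv1 & sv2 & sv3 & sv4).
  apply in_region_cases in hr.
  assert (j = 3%nat).
  { destruct hr as [(-> & hh & _)|[(-> & _ & hh)|[(-> & _)|(-> & hh & _)]]]; auto; try lra.
    rewrite hv1, sv2 in hh by auto. lra. }
  subst j. rewrite sv3 in fv by auto.
  assert (hu s' = 0).
  { assert (hv2 := fv s' ltac:(lra)). rewrite hv0 in hv2. apply Rmult_integral in h2. destruct h2;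
    auto. lra. }
  assert (FU : forall t, s <= t <= s' -> hu t = drift b e 3 * expm1_div (rate a e 3) (t - s')).
  { intros t ht. rewrite (fu s' t) by lra. rewrite H0. ring. }
  exists (s' - s). split. lra. split.
  rewrite <- hu0, FU by lra. f_equal. f_equal. ring.
  replace (s + (s' - s)) with s' by ring. split. auto.
  intros t ht. split. apply FU; lra. rewrite (fv t ht), hv0. ring.
Qed.

Lemma arc_from_pos_u a b c d e hu hv hw Th L s x : periodic_data a b c d e hu hv hw Th L
  -> Rabs e * ab_norm a b <= /2 ->
  hu s = x -> hv s = 0 -> 0 < x ->
  exists Y, 0 < Y /\ x = drift b e 1 * expm1_div (rate a e 1) (- Y) /\
  (forall t, s < t < s + Y -> in_region 1 (hu t) (hv t)) /\
  (forall t, s <= t <= s + Y -> hu t = drift b e 1 * expm1_div (rate a e 1) (t - (s + Y)) /\ hv t = t - s).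
Proof.
  intros H he hu0 hv0 hm. destruct (drift_signs a b e he) as (p1 & p2 & p3 & p4 & _).
  pose proof H as (HC & _).
  destruct (arc_after_crossing _ _ _ _ _ _ _ _ _ _ s H ltac:(rewrite hv0; ring))
    as [s' [j (h1 & h2 & h3 & hj & fv & fu)]].
  destruct (continuity_pt_elim hu s (proj1 (HC s)) (x/2) ltac:(lra)) as [dl [hdl kd]].
  set (ts := s + Rmin dl (s' - s) / 2).
  assert (hts : s < ts < s' /\ ts - s < dl) by (unfold ts; assert (h := Rmin_l dl (s'-s));
    assert (h' := Rmin_r dl (s'-s));
    assert (0 < Rmin dl (s' - s)) by (apply Rmin_pos; lra); lra).
  assert (hu1 : 0 < hu ts).
  { assert (k := kd ts ltac:(rewrite Rabs_right; lra)). rewrite hu0 in k. apply Rabs_def2 in k. lra. }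
  assert (hr := hj ts ltac:(lra)). assert (hv1 := fv ts ltac:(lra)). rewrite hv0 in hv1.
  assert (jv := in_region_index _ _ _ hr). destruct (sv_values j jv) as (sv1 & sv2 & sv3 & sv4).
  apply in_region_cases in hr.
  assert (j = 1%nat).
  { destruct hr as [(-> & _)|[(-> & hh & _)|[(-> & hh & _)|(-> & _ & hh)]]]; auto; try lra.
    rewrite hv1, sv4 in hh by auto. lra. }
  subst j. rewrite sv1 in fv by auto.
  assert (hu s' = 0).
  { assert (hv2 := fv s' ltac:(lra)). rewrite hv0 in hv2. apply Rmult_integral in h2. destruct h2;
    auto. lra. }
  assert (FU : forall t, s <= t <= s' -> hu t = drift b e 1 * expm1_div (rate a e 1) (t - s')).
  { intros t ht. rewrite (fu s' t) by lra. rewrite H0. ring. }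
  exists (s' - s). split. lra. split.
  rewrite <- hu0, FU by lra. f_equal. f_equal. ring.
  replace (s + (s' - s)) with s' by ring. split. auto.
  intros t ht. split. apply FU; lra. rewrite (fv t ht), hv0. ring.
Qed.

Lemma full_turn a b c d e hu hv hw Th L s Y : periodic_data a b c d e hu hv hw Th L
  -> Rabs e * ab_norm a b <= /2 ->
  hu s = 0 -> hv s = Y -> 0 < Y ->
  exists Z Y', 0 < Z /\ 0 < Y' /\ left_transit a b e Y Z /\ right_transit a b e Z Y' /\
   hu (s + Y + Z) = 0 /\ hv (s + Y + Z) = - Z /\
   hu (s + Y + 2*Z + Y') = 0 /\ hv (s + Y + 2*Z + Y') = Y' /\
   (forall t, s < t < s + Y -> in_region 2 (hu t) (hv t)) /\
   (forall t, s <= t <= s + Y -> hu t = drift b e 2 * expm1_div (rate a e 2) (t - s) /\ hv t = Y - (t - s)) /\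
   (forall t, s + Y < t < s + Y + Z -> in_region 3 (hu t) (hv t)) /\
   (forall t, s + Y <= t <= s + Y + Z -> hu t = drift b e 3 * expm1_div (rate a e 3)
     (t - (s + Y + Z)) /\ hv t = - (t - (s + Y))) /\
   (forall t, s + Y + Z < t < s + Y + 2*Z -> in_region 4 (hu t) (hv t)) /\
   (forall t, s + Y + Z <= t <= s + Y + 2*Z -> hu t = drift b e 4 * expm1_div (rate a e 4)
     (t - (s + Y + Z)) /\ hv t = - Z + (t - (s + Y + Z))) /\
   (forall t, s + Y + 2*Z < t < s + Y + 2*Z + Y' -> in_region 1 (hu t) (hv t)) /\
   (forall t, s + Y + 2*Z <= t <= s + Y + 2*Z + Y' -> hu t = drift b e 1 * expm1_div (rate a e 1)
     (t - (s + Y + 2*Z + Y')) /\ hv t = t - (s + Y + 2*Z)).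
Proof.
  intros H he hu0 hv0 hY. destruct (drift_signs a b e he) as (p1 & p2 & p3 & p4 & _).
  destruct (arc_from_pos_v _ _ _ _ _ _ _ _ _ _ s Y H he hu0 hv0 hY) as [rA fA].
  destruct (fA (s + Y) ltac:(lra)) as [u1 v1]. replace (s + Y - s) with Y in u1, v1 by ring.
  assert (hm : drift b e 2 * expm1_div (rate a e 2) Y < 0) by (assert (0 < expm1_div (rate a e 2) Y)
    by (apply expm1_div_pos; lra); nra).
  destruct (arc_from_neg_u _ _ _ _ _ _ _ _ _ _ (s + Y) _ H he u1 ltac:(rewrite v1; ring) hm)
    as [Z (hZ & eZ & rB & fB)].
  destruct (fB (s + Y + Z) ltac:(lra)) as [u2 v2]. replace (s + Y + Z - (s + Y + Z)) with 0 in u2 by ring.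
  rewrite expm1_div_0, Rmult_0_r in u2. replace (- (s + Y + Z - (s + Y))) with (- Z) in v2 by ring.
  destruct (arc_from_neg_v _ _ _ _ _ _ _ _ _ _ (s + Y + Z) Z H he u2 v2 hZ) as [rC fC].
  destruct (fC (s + Y + Z + Z) ltac:(lra)) as [u3 v3]. replace (s + Y + Z + Z - (s + Y + Z))
    with Z in u3, v3 by ring.
  replace (- Z + Z) with 0 in v3 by ring.
  assert (hx : 0 < drift b e 4 * expm1_div (rate a e 4) Z) by (assert (0 < expm1_div (rate a e 4) Z)
    by (apply expm1_div_pos; lra); nra).
  destruct (arc_from_pos_u _ _ _ _ _ _ _ _ _ _ (s + Y + Z + Z) _ H he u3 v3 hx) as [Y' (hY' & eY' & rD & fD)].
  destruct (fD (s + Y + Z + Z + Y') ltac:(lra)) as [u4 v4].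
  replace (s + Y + Z + Z + Y' - (s + Y + Z + Z + Y')) with 0 in u4 by ring.
  rewrite expm1_div_0, Rmult_0_r in u4. replace (s + Y + Z + Z + Y' - (s + Y + Z + Z)) with Y' in v4 by ring.
  exists Z, Y'. replace (s + Y + 2*Z) with (s + Y + Z + Z) by ring.
  repeat match goal with |- _ /\ _ => split end; auto.
Qed.

(** * Isolation of the explicit orbit *)

Lemma u_arc_lower_bound P q x : /2 <= Rabs P -> Rabs q * Rabs x <= /2
  -> Rabs x / 4 <= Rabs (P * expm1_div q x).
Proof.
  intros hP hq. rewrite Rabs_mult.
  destruct (Rtotal_order x 0) as [l|[->|g]].
  - rewrite (Rabs_left x) in hq |- * by lra. destruct (expm1_div_bounds q (-x) ltac:(lra) hq) as [_ [_ k]].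
    rewrite Ropp_involutive in k. rewrite (Rabs_left (expm1_div q x)) by lra.
    assert (/2 * (- x / 2) <= Rabs P * - expm1_div q x) by (apply Rmult_le_compat; lra). lra.
  - rewrite Rabs_R0, expm1_div_0, Rabs_R0. lra.
  - rewrite (Rabs_right x) in hq |- * by lra. destruct (expm1_div_bounds q x g hq) as [[k _] _].
    rewrite (Rabs_right (expm1_div q x)) by lra.
    assert (/2 * (x / 2) <= Rabs P * expm1_div q x) by (apply Rmult_le_compat; lra). lra.
Qed.

Lemma orbit_tube a b e y z : closing_heights a b e y z -> Rabs e * ab_norm a b * (2*y+2*z) <= /2 ->
  forall t, Rmin y z / 4 <= Rabs (orbit_u a b e y z t) + Rabs (orbit_v y z t) /\
   (forall r, r <= Rmin y z / 4 -> Rabs (orbit_u a b e y z t) < r -> 0 <= orbit_v y z t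
     -> Rabs (orbit_v y z t - y) < 4*r) /\
   (forall r, r <= Rmin y z / 4 -> Rabs (orbit_u a b e y z t) < r -> orbit_v y z t <= 0
     -> Rabs (orbit_v y z t + z) < 4*r).
Proof.
  intros H hq t. pose proof H as (hy & hz & h1 & h2 & he).
  destruct (drift_signs a b e he) as (p1 & p2 & p3 & p4 & _).
  destruct (rate_bounds a b e) as (q1 & q2 & q3 & q4 & _).
  assert (hT : 0 < loop_time y z) by (unfold loop_time; lra).
  unfold orbit_u, orbit_v. rewrite !periodize_base. set (sg := t - period_base (loop_time y z) t).
  assert (hs := period_base_range (loop_time y z) t hT). fold sg in hs. unfold loop_time in hs.
  assert (my := Rmin_l y z). assert (mz := Rmin_r y z).
  assert (LB : forall j x, (j = 1 \/ j = 2 \/ j = 3 \/ j = 4)%nat -> Rabs x <= 2*y+2*z ->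
    Rabs x / 4 <= Rabs (drift b e j * expm1_div (rate a e j) x)).
  { intros j x hj hx. apply u_arc_lower_bound.
    - destruct hj as [ -> | [ -> | [ -> | -> ] ] ];
      [rewrite Rabs_left| rewrite Rabs_left| rewrite Rabs_right| rewrite Rabs_right]; lra.
    - assert (Rabs (rate a e j) <= Rabs e * ab_norm a b) by (destruct hj as [ -> | [ -> | [ -> |
      -> ] ] ]; auto).
      assert (0 <= Rabs (rate a e j)) by apply Rabs_pos. assert (0 <= Rabs x) by apply Rabs_pos.
      apply Rle_trans with (Rabs e * ab_norm a b * (2*y+2*z)); auto. apply Rmult_le_compat; auto. }
  unfold u_loop, v_loop, uA, uB, uC, uD, vA, vC, u_arc, loop_time.
  destruct (Rle_dec sg y) as [l1|l1].
  { rewrite !concat4_A by lra. assert (k := LB 2%nat (sg - 0) ltac:(auto) ltac:(rewrite Rabs_right; lra)).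
    rewrite Rabs_right in k by lra. rewrite (Rabs_right (y + -1 * sg)) by lra.
    split. lra. split.
    - intros r hr hu hv. rewrite Rabs_left1 by lra. lra.
    - intros r hr hu hv. assert (sg = y) by lra. subst sg. lra. }
  destruct (Rle_dec sg (y+z)) as [l2|l2].
  { rewrite !concat4_B by lra. assert (k := LB 3%nat (sg - (y+z)) ltac:(auto) ltac:(rewrite Rabs_left1; lra)).
    rewrite Rabs_left1 in k by lra. rewrite (Rabs_left1 (y + -1 * sg)) by lra.
    split. lra. split.
    - intros r hr hu hv. lra.
    - intros r hr hu hv. rewrite Rabs_lt_between. lra. }
  destruct (Rle_dec sg (y+2*z)) as [l3|l3].
  { rewrite !concat4_C by lra. assert (k := LB 4%nat (sg - (y+z)) ltac:(auto) ltac:(rewrite Rabs_right; lra)).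
    rewrite Rabs_right in k by lra. rewrite (Rabs_left1 (- (y + 2 * z) + 1 * sg)) by lra.
    split. lra. split.
    - intros r hr hu hv. assert (sg = y + 2*z) by lra. subst sg. lra.
    - intros r hr hu hv. rewrite Rabs_lt_between. lra. }
  { rewrite !concat4_D by lra. assert (k := LB 1%nat (sg - (2*y+2*z)) ltac:(auto)
    ltac:(rewrite Rabs_left1; lra)).
    rewrite Rabs_left1 in k by lra. rewrite (Rabs_right (- (y + 2 * z) + 1 * sg)) by lra.
    split. lra. split.
    - intros r hr hu hv. rewrite Rabs_lt_between. lra.
    - intros r hr hu hv. lra. }
Qed.

Lemma dist3_bounds x1 y1 z1 x2 y2 z2 r : dist3 x1 y1 z1 x2 y2 z2 < r ->
  Rabs (x1 - x2) < r /\ Rabs (y1 - y2) < r /\ Rabs (z1 - z2) < r.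
Proof.
  intros H. unfold dist3 in H.
  assert (G : forall u v w, Rabs u <= sqrt (u^2 + v^2 + w^2)).
  { intros u v w. rewrite <- sqrt_Rsqr_abs. apply sqrt_le_1_alt. unfold Rsqr.
    assert (0 <= v^2) by apply pow2_ge_0. assert (0 <= w^2) by apply pow2_ge_0. simpl. lra. }
  split; [|split].
  - eapply Rle_lt_trans; [apply G|]. apply H.
  - eapply Rle_lt_trans; [apply (G (y1 - y2) (x1 - x2) (z1 - z2))|]. replace ((y1 - y2)
    ^ 2 + (x1 - x2) ^ 2 + (z1 - z2) ^ 2) with
      ((x1 - x2) ^ 2 + (y1 - y2) ^ 2 + (z1 - z2) ^ 2) by ring. apply H.
  - eapply Rle_lt_trans; [apply (G (z1 - z2) (x1 - x2) (y1 - y2))|]. replace ((z1 - z2)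
    ^ 2 + (x1 - x2) ^ 2 + (y1 - y2) ^ 2) with
      ((x1 - x2) ^ 2 + (y1 - y2) ^ 2 + (z1 - z2) ^ 2) by ring. apply H.
Qed.

Lemma near_orbit_axes a b e y z (hu hv hw : R -> R) r gw : closing_heights a b e y z
  -> Rabs e * ab_norm a b * (2*y+2*z) <= /2 ->
  0 < r -> r <= Rmin y z / 8 ->
  (forall s, exists t, dist3 (hu s) (hv s) (hw s) (orbit_u a b e y z t) (orbit_v y z t) (gw t) < r) ->
  (forall s, ~ (hu s = 0 /\ hv s = 0)) /\
  (forall s, hu s = 0 -> 0 < hv s -> Rabs (hv s - y) < 5 * r) /\
  (forall s, hu s = 0 -> hv s < 0 -> Rabs (hv s + z) < 5 * r).
Proof.
  intros H hq hr hr2 Ht.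
  assert (K : forall s, exists t, Rabs (hu s - orbit_u a b e y z t) < r /\ Rabs (hv s - orbit_v y z t) < r /\
     Rmin y z / 4 <= Rabs (orbit_u a b e y z t) + Rabs (orbit_v y z t) /\
     (forall r, r <= Rmin y z / 4 -> Rabs (orbit_u a b e y z t) < r -> 0 <= orbit_v y z t
       -> Rabs (orbit_v y z t - y) < 4*r) /\
     (forall r, r <= Rmin y z / 4 -> Rabs (orbit_u a b e y z t) < r -> orbit_v y z t <= 0
       -> Rabs (orbit_v y z t + z) < 4*r)).
  { intros s. destruct (Ht s) as [t ht]. apply dist3_bounds in ht. exists t.
    destruct (orbit_tube a b e y z H hq t) as (k1 & k2 & k3). destruct ht as (d1 & d2 & _). auto. }
  split; [|split].
  - intros s [h1 h2]. destruct (K s) as [t (d1 & d2 & k1 & _)]. rewrite h1 in d1. rewrite h2 in d2.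
    rewrite Rabs_minus_sym, Rminus_0_r in d1, d2. lra.
  - intros s h1 h2. destruct (K s) as [t (d1 & d2 & k1 & k2 & _)]. rewrite h1 in d1.
    rewrite Rabs_minus_sym, Rminus_0_r in d1.
    destruct (Rle_dec 0 (orbit_v y z t)).
    + assert (k := k2 r ltac:(lra) d1 r0). apply Rabs_def2 in k. apply Rabs_def2 in d2. apply Rabs_def1; lra.
    + exfalso. apply Rabs_def2 in d2. rewrite (Rabs_left (orbit_v y z t)) in k1 by lra. lra.
  - intros s h1 h2. destruct (K s) as [t (d1 & d2 & k1 & _ & k3)]. rewrite h1 in d1.
    rewrite Rabs_minus_sym, Rminus_0_r in d1.
    destruct (Rle_dec (orbit_v y z t) 0).
    + assert (k := k3 r ltac:(lra) d1 r0). apply Rabs_def2 in k. apply Rabs_def2 in d2. apply Rabs_def1; lra.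
    + exfalso. apply Rabs_def2 in d2. rewrite (Rabs_right (orbit_v y z t)) in k1 by lra. lra.
Qed.

Lemma periodic_data_crossing a b c d e hu hv hw Th L : periodic_data a b c d e hu hv hw Th L
  -> exists t, hu t * hv t = 0.
Proof.
  intros H. pose proof H as (HC & HT & HP & HL & HD).
  apply NNPP. intros NZ.
  assert (nz : forall t, -1 < t < Th + 1 -> hu t * hv t <> 0) by (intros t _ h; apply NZ; exists t; auto).
  destruct (region_const _ _ _ _ _ _ _ _ _ _ H (-1) (Th+1) ltac:(lra) nz) as [j hj].
  destruct (arc_formulas _ _ _ _ _ _ _ _ _ _ j (-1) (Th+1) H ltac:(lra) hj) as [fv _].
  assert (jv := in_region_index _ _ _ (hj 0 ltac:(lra))).
  assert (sv j <> 0) by (destruct jv as [ -> | [ -> | [ -> | -> ] ] ]; simpl; lra).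
  assert (e1 := fv 0 ltac:(lra)). assert (e2 := fv Th ltac:(lra)).
  destruct (HP 0) as (_ & e3 & _). rewrite Rplus_0_l in e3.
  assert (sv j * Th = 0) by lra. apply Rmult_integral in H1. destruct H1; lra.
Qed.

Lemma reaches_pos_v_axis a b c d e hu hv hw Th L : periodic_data a b c d e hu hv hw Th L
  -> Rabs e * ab_norm a b <= /2 ->
  (forall s, ~ (hu s = 0 /\ hv s = 0)) -> exists s, hu s = 0 /\ 0 < hv s.
Proof.
  intros H he NO. destruct (drift_signs a b e he) as (p1 & p2 & p3 & p4 & _).
  destruct (periodic_data_crossing _ _ _ _ _ _ _ _ _ _ H) as [s0 hz].
  assert (FU : forall s, 0 < hu s -> hv s = 0 -> exists s', hu s' = 0 /\ 0 < hv s').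
  { intros s h1 h2. destruct (arc_from_pos_u _ _ _ _ _ _ _ _ _ _ s _ H he eq_refl h2 h1)
    as [Y (hY & _ & _ & f)].
    exists (s + Y). destruct (f (s + Y) ltac:(lra)) as [u v]. split.
    rewrite u. replace (s + Y - (s + Y)) with 0 by ring. rewrite expm1_div_0; ring. rewrite v; lra. }
  assert (FV : forall s, hu s = 0 -> hv s < 0 -> exists s', hu s' = 0 /\ 0 < hv s').
  { intros s h1 h2. destruct (arc_from_neg_v _ _ _ _ _ _ _ _ _ _ s (- hv s) H he h1 ltac:(ring)
    ltac:(lra)) as [_ f].
    destruct (f (s + - hv s) ltac:(lra)) as [u v]. apply (FU (s + - hv s)).
    rewrite u. replace (s + - hv s - s) with (- hv s) by ring. assert (0 < expm1_div (rate a e 4)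
      (- hv s)) by (apply expm1_div_pos; lra). nra.
    rewrite v. ring. }
  apply Rmult_integral in hz. destruct hz as [h1|h2].
  - destruct (Rtotal_order (hv s0) 0) as [l|[E|g]].
    + apply (FV s0 h1 l).
    + exfalso; apply (NO s0); auto.
    + exists s0; auto.
  - destruct (Rtotal_order (hu s0) 0) as [l|[E|g]].
    + destruct (arc_from_neg_u _ _ _ _ _ _ _ _ _ _ s0 _ H he eq_refl h2 l) as [Z (hZ & _ & _ & f)].
      destruct (f (s0 + Z) ltac:(lra)) as [u v]. apply (FV (s0 + Z)).
      rewrite u. replace (s0 + Z - (s0 + Z)) with 0 by ring. rewrite expm1_div_0; ring. rewrite v; lra.
    + exfalso; apply (NO s0); auto.
    + apply (FU s0 g h2).
Qed.

Definition pos_v_height (hu hv : R -> R) (Y : R) := 0 < Y /\ exists t, hu t = 0 /\ hv t = Y.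

Lemma pos_v_heights_finite a b c d e hu hv hw Th L Y : periodic_data a b c d e hu hv hw Th L ->
  pos_v_height hu hv Y -> In Y (map hv L).
Proof.
  intros H [hY [t [h1 h2]]]. pose proof H as (HC & HT & HP & HL & HD).
  set (t' := t - period_base Th t).
  destruct (periodic_data_shift_int _ _ _ _ _ _ _ _ _ _ H (- Int_part (t / Th)) t) as (e1 & e2 & _).
  rewrite opp_IZR in e1, e2.
  replace (t + - IZR (Int_part (t / Th)) * Th) with t' in e1, e2 by (unfold t', period_base; ring).
  assert (hr := period_base_range Th t HT). fold t' in hr.
  rewrite <- h2, <- e2. apply in_map. apply HL. lra. rewrite e1, e2, h1. ring.
Qed.

Lemma pos_v_heights_step a b c d e hu hv hw Th L al de Y : periodic_data a b c d e hu hv hw Th L ->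
  Rabs e * ab_norm a b <= /2 ->
  (forall s, hu s = 0 -> 0 < hv s -> Rabs (hv s - al) <= de) ->
  (forall s, hu s = 0 -> hv s < 0 -> Rabs (- hv s - al) <= de) ->
  pos_v_height hu hv Y -> exists Z Y', left_transit a b e Y Z /\ right_transit a b e Z Y' /\
    pos_v_height hu hv Y' /\ Rabs (Y - al) <= de /\ Rabs (Z - al) <= de /\ Rabs (Y' - al) <= de.
Proof.
  intros H he T1 T2 [hY [t [h1 h2]]].
  destruct (full_turn _ _ _ _ _ _ _ _ _ _ t Y H he h1 h2 hY)
    as [Z [Y' (hZ & hY' & E1 & E2 & u2 & v2 & u4 & v4 & _)]].
  exists Z, Y'. split; auto. split; auto. split.
  { split; auto. exists (t + Y + 2 * Z + Y'); auto. }
  split. { rewrite <- h2. apply T1; auto. rewrite h2; auto. }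
  split. { replace Z with (- hv (t + Y + Z)) by lra. apply T2; auto. lra. }
  rewrite <- v4. apply T1; auto. lra.
Qed.

(* The heights of the positive v-axis crossings form a finite set invariant under the return
   map; by [monotone_return] its extreme element on either side of [y] would be moved further
   away from, or closer to, the fixed point [y], which is impossible. *)
Lemma pos_v_crossing_height a b c d e hu hv hw Th L y z al de stab :
  periodic_data a b c d e hu hv hw Th L -> Rabs e * ab_norm a b <= /2 ->
  left_transit a b e y z -> right_transit a b e z y -> monotone_return a b e al de stab ->
  (forall s, hu s = 0 -> 0 < hv s -> Rabs (hv s - al) <= de) ->
  (forall s, hu s = 0 -> hv s < 0 -> Rabs (- hv s - al) <= de) ->
  Rabs (y - al) <= de -> Rabs (z - al) <= de ->
  forall s, hu s = 0 -> 0 < hv s -> hv s = y.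
Proof.
  intros H he Ey Ez HS T1 T2 hy hz s h1 h2.
  set (Sy := pos_v_height hu hv).
  assert (fin : forall Y, Sy Y -> In Y (map hv L)) by (intros; eapply pos_v_heights_finite; eauto).
  assert (step := fun Y => pos_v_heights_step a b c d e hu hv hw Th L al de Y H he T1 T2).
  assert (S0 : Sy (hv s)) by (split; auto; exists s; auto).
  destruct (Rtotal_order (hv s) y) as [lt|[eq|gt]]; auto; exfalso.
  - destruct stab.
    + destruct (list_min (map hv L) (fun Y => Sy Y /\ Y < y)) as [m [hm [[Sm lm] mm]]].
      { exists (hv s). split; auto. }
      destruct (step m Sm) as [Zm [m' (E1 & E2 & Sm' & d1 & d2 & d3)]].
      destruct (HS m Zm m' y z y d1 d2 d3 hy hz hy E1 E2 Ey Ez lm) as [k1 k2].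
      assert (m <= m') by (apply mm; auto; split; auto). lra.
    + destruct (list_max (map hv L) (fun Y => Sy Y /\ Y < y)) as [m [hm [[Sm lm] mm]]].
      { exists (hv s). split; auto. }
      destruct (step m Sm) as [Zm [m' (E1 & E2 & Sm' & d1 & d2 & d3)]].
      destruct (HS m Zm m' y z y d1 d2 d3 hy hz hy E1 E2 Ey Ez lm) as [k1 k2].
      assert (m' <= m) by (apply mm; auto; split; auto). lra.
  - destruct stab.
    + destruct (list_max (map hv L) (fun Y => Sy Y /\ y < Y)) as [m [hm [[Sm lm] mm]]].
      { exists (hv s). split; auto. }
      destruct (step m Sm) as [Zm [m' (E1 & E2 & Sm' & d1 & d2 & d3)]].
      destruct (HS y z y m Zm m' hy hz hy d1 d2 d3 Ey Ez E1 E2 lm) as [k1 k2].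
      assert (m' <= m) by (apply mm; auto; split; auto; lra). lra.
    + destruct (list_min (map hv L) (fun Y => Sy Y /\ y < Y)) as [m [hm [[Sm lm] mm]]].
      { exists (hv s). split; auto. }
      destruct (step m Sm) as [Zm [m' (E1 & E2 & Sm' & d1 & d2 & d3)]].
      destruct (HS y z y m Zm m' hy hz hy d1 d2 d3 Ey Ez E1 E2 lm) as [k1 k2].
      assert (m <= m') by (apply mm; auto; split; auto; lra). lra.
Qed.

Lemma w_difference_step a b c d e hu hv hw Th L gu gv gw s s1 s2 j : periodic_data a b c d e hu hv hw Th L ->
  periodic_orbit a b c d e gu gv gw -> s1 < s2 ->
  (forall t, s1 < t < s2 -> in_region j (hu t) (hv t)) ->
  (forall t, s1 <= t <= s2 -> hu t = gu (t - s) /\ hv t = gv (t - s)) ->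
  forall t, s1 <= t <= s2 -> (hw t - gw (t - s)) * exp t = (hw s1 - gw (s1 - s)) * exp s1.
Proof.
  intros H G hs hr hm. pose proof H as (HC & HT & HP & HL & HD). destruct G as (GC & _ & _ & _ & _ & GD).
  apply (w_difference_decay hw (fun x => gw (x - s)) s1 s2); auto.
  - intros t ht. destruct (hm t ltac:(lra)) as [m1 m2].
    assert (hr' : in_region j (gu (t - s)) (gv (t - s))) by (rewrite <- m1, <- m2; auto).
    destruct (HD t j (hr t ht)) as (_ & _ & d1). destruct (GD (t - s) j hr') as (_ & _ & d2).
    apply derivable_pt_lim_shift in d2.
    assert (dd := derivable_pt_lim_minus _ _ _ _ _ d1 d2).
    replace (- (hw t - gw (t - s))) with (Xw c d e j (hu t) (hw t) - Xw c d e j (gu (t - s)) (gw (t - s))).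
    apply derivable_pt_lim_ext with (f := minus_fct hw (fun x => gw (x - s))). intros; reflexivity. auto.
    rewrite m1. unfold Xw. ring.
  - intros t ht. split. apply HC. apply continuity_pt_shift. apply GC.
Qed.

Lemma full_turn_matches a b c d e hu hv hw Th L y z s : periodic_data a b c d e hu hv hw Th L
  -> closing_heights a b e y z ->
  hu s = 0 -> hv s = y ->
  hu (s + loop_time y z) = 0 /\ hv (s + loop_time y z) = y /\
  (forall t, s <= t <= s + loop_time y z -> hu t = orbit_u a b e y z (t - s) /\ hv t = orbit_v y z (t - s)) /\
  (forall t, s <= t <= s + loop_time y z -> (hw t - orbit_w a b c d e y z (t - s))
    * exp t = (hw s - orbit_w a b c d e y z 0) * exp s).
Proof.
  intros H Hg h1 h2. pose proof Hg as (hy & hz & Ey & Ez & he).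
  destruct (drift_signs a b e he) as (p1 & p2 & p3 & p4 & _).
  destruct (full_turn _ _ _ _ _ _ _ _ _ _ s y H he h1 h2 hy)
    as [Z [Y' (hZ & hY' & E1 & E2 & u2 & v2 & u4 & v4 & rA & fA & rB & fB & rC & fC & rD & fD)]].
  assert (Z = z) by (apply (left_transit_unique a b e y); auto). subst Z.
  assert (Y' = y) by (apply (right_transit_unique a b e z); auto). subst Y'.
  assert (hT : 0 < loop_time y z) by (unfold loop_time; lra).
  assert (TT : s + y + 2*z + y = s + loop_time y z) by (unfold loop_time; ring).
  rewrite TT in u4, v4, rD, fD.
  assert (G0 : orbit_u a b e y z (loop_time y z) = 0 /\ orbit_v y z (loop_time y z) = y).
  { unfold orbit_u, orbit_v. assert (k1 := periodize_plus_period (loop_time y z) (u_loop a b e y z)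
    0 hT). assert (k2 := periodize_plus_period (loop_time y z) (v_loop y z) 0 hT).
    rewrite Rplus_0_l in k1, k2. rewrite k1, k2.
    rewrite !periodize_in by lra. unfold u_loop, v_loop. rewrite !concat4_A by lra. unfold uA,
      u_arc, vA. replace (0 - 0) with 0 by ring.
    rewrite expm1_div_0. split; ring. }
  assert (M : forall t, s <= t <= s + loop_time y z -> hu t = orbit_u a b e y z (t - s)
    /\ hv t = orbit_v y z (t - s)).
  { intros t ht. destruct (Req_dec t (s + loop_time y z)) as [->|ne].
    { replace (s + loop_time y z - s) with (loop_time y z) by ring. rewrite u4, v4. destruct G0; auto. }
    unfold orbit_u, orbit_v. rewrite !periodize_in by lra. unfold u_loop, v_loop, loop_time in *.
    destruct (Rle_dec t (s + y)).
    { rewrite !concat4_A by lra. destruct (fA t ltac:(lra)) as [a1 a2]. unfold uA, u_arc, vA.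
      rewrite a1, a2. split; [f_equal; f_equal|]; ring. }
    destruct (Rle_dec t (s + y + z)).
    { rewrite !concat4_B by lra. destruct (fB t ltac:(lra)) as [a1 a2]. unfold uB, u_arc, vA.
      rewrite a1, a2. split; [f_equal; f_equal|]; ring. }
    destruct (Rle_dec t (s + y + 2*z)).
    { rewrite !concat4_C by lra. destruct (fC t ltac:(lra)) as [a1 a2]. unfold uC, u_arc, vC.
      rewrite a1, a2. split; [f_equal; f_equal|]; ring. }
    { rewrite !concat4_D by lra. destruct (fD t ltac:(lra)) as [a1 a2]. unfold uD, u_arc, vC, loop_time.
      rewrite a1, a2. split; [f_equal; f_equal|]; ring. } }
  split; auto. split; auto. split; auto.
  assert (Gpo := orbit_periodic a b c d e y z Hg).
  assert (W1 := w_difference_step _ _ _ _ _ _ _ _ _ _ _ _ _ s s (s + y) 2%nat H Gpo ltac:(lra)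
    rA ltac:(intros; apply M; unfold loop_time; lra)).
  assert (W2 := w_difference_step _ _ _ _ _ _ _ _ _ _ _ _ _ s (s + y) (s + y + z)
    3%nat H Gpo ltac:(lra) rB ltac:(intros; apply M; unfold loop_time; lra)).
  assert (W3 := w_difference_step _ _ _ _ _ _ _ _ _ _ _ _ _ s (s + y + z) (s + y + 2*z)
    4%nat H Gpo ltac:(lra) rC ltac:(intros; apply M; unfold loop_time; lra)).
  assert (W4 := w_difference_step _ _ _ _ _ _ _ _ _ _ _ _ _ s (s + y + 2*z) (s + loop_time y z)
    1%nat H Gpo ltac:(unfold loop_time; lra) rD ltac:(intros; apply M; unfold loop_time in *; lra)).
  replace (s - s) with 0 in W1 by ring.
  assert (k1 := W1 (s + y) ltac:(lra)). assert (k2 := W2 (s + y + z) ltac:(lra)).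
  assert (k3 := W3 (s + y + 2*z) ltac:(lra)).
  intros t ht.
  destruct (Rle_dec t (s + y)). apply W1; lra.
  destruct (Rle_dec t (s + y + z)). rewrite W2 by lra. auto.
  destruct (Rle_dec t (s + y + 2*z)). rewrite W3 by lra. rewrite k2; auto.
  rewrite W4 by (unfold loop_time in *; lra). rewrite k3, k2; auto.
Qed.

Lemma orbit_pos_v_start a b e y z sg : closing_heights a b e y z -> 0 <= sg < loop_time y z ->
  u_loop a b e y z sg = 0 -> v_loop y z sg = y -> sg = 0.
Proof.
  intros H hs hu hv. pose proof H as (hy & hz & _).
  destruct (arc_signs a b e y z H) as (sA & sB & sC & sD). unfold loop_time in hs.
  unfold u_loop, v_loop in *.
  destruct (Req_dec sg 0); auto. exfalso.
  destruct (Rle_dec sg y).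
  { rewrite concat4_A in hu, hv by lra. destruct (Req_dec sg y). subst. unfold vA in hv. lra.
    destruct (sA sg ltac:(lra)). lra. }
  destruct (Rle_dec sg (y+z)).
  { rewrite concat4_B in hv by lra. unfold vA in hv. lra. }
  destruct (Rle_dec sg (y+2*z)).
  { rewrite concat4_C in hv by lra. unfold vC in hv. lra. }
  rewrite concat4_D in hu by lra. destruct (sD sg ltac:(lra)). lra.
Qed.

Lemma turns_match a b c d e hu hv hw Th L y z s0 : periodic_data a b c d e hu hv hw Th L ->
  closing_heights a b e y z -> hu s0 = 0 -> hv s0 = y ->
  forall n : nat, hu (s0 + INR n * loop_time y z) = 0 /\ hv (s0 + INR n * loop_time y z) = y /\
    (hw (s0 + INR n * loop_time y z) - orbit_w a b c d e y z 0) * exp (s0 + INR n * loop_time y z)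
    = (hw s0 - orbit_w a b c d e y z 0) * exp s0.
Proof.
  intros H Hg h0u h0v n. pose proof Hg as (hy & hz & _).
  induction n as [|n IHn].
  - simpl. rewrite Rmult_0_l, Rplus_0_r. auto.
  - destruct IHn as (i1 & i2 & i3).
    destruct (full_turn_matches _ _ _ _ _ _ _ _ _ _ y z _ H Hg i1 i2) as (l1 & l2 & _ & l4).
    rewrite S_INR. replace (s0 + (INR n + 1) * loop_time y z)
      with (s0 + INR n * loop_time y z + loop_time y z) by ring.
    split; auto. split; auto.
    rewrite <- i3, <- (l4 (s0 + INR n * loop_time y z + loop_time y z)) by (unfold loop_time; lra).
    f_equal. f_equal. replace (s0 + INR n * loop_time y z + loop_time y z - (s0 + INR n * loop_time y z))
      with (0 + loop_time y z) by ring.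
    unfold orbit_w. symmetry. apply periodize_plus_period. unfold loop_time; lra.
Qed.

Lemma follows_orbit a b c d e hu hv hw Th L y z s0 : periodic_data a b c d e hu hv hw Th L ->
  closing_heights a b e y z -> hu s0 = 0 -> hv s0 = y ->
  forall t, s0 <= t -> hu t = orbit_u a b e y z (t - s0) /\ hv t = orbit_v y z (t - s0) /\
    (hw t - orbit_w a b c d e y z (t - s0)) * exp t = (hw s0 - orbit_w a b c d e y z 0) * exp s0.
Proof.
  intros H Hg h0u h0v t ht. pose proof Hg as (hy & hz & _).
  set (Tg := loop_time y z). assert (hTg : 0 < Tg) by (unfold Tg, loop_time; lra).
  set (k := Int_part ((t - s0) / Tg)). destruct (Int_part_bounds ((t - s0)/Tg)) as [f1 f2]. fold k in f1, f2.
  assert (k0 : (0 <= k)%Z).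
  { assert (q1 : 0 <= (t - s0)/Tg) by (apply Rmult_le_pos; [lra| left; apply Rinv_0_lt_compat; lra]).
    assert (q2 : IZR (-1) < IZR k) by (simpl; lra). apply lt_IZR in q2. lia. }
  set (n := Z.to_nat k). assert (hn : INR n = IZR k) by (unfold n; rewrite INR_IZR_INZ, Z2Nat.id; auto).
  destruct (turns_match a b c d e hu hv hw Th L y z s0 H Hg h0u h0v n) as (i1 & i2 & i3).
  destruct (full_turn_matches _ _ _ _ _ _ _ _ _ _ y z _ H Hg i1 i2) as (_ & _ & l3 & l4).
  assert (rt : s0 + INR n * Tg <= t <= s0 + INR n * Tg + loop_time y z).
  { rewrite hn. apply Rmult_le_compat_r with (r := Tg) in f1; [|lra].
    apply Rmult_lt_compat_r with (r := Tg) in f2; [|lra].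
    replace ((t - s0) / Tg * Tg) with (t - s0) in f1, f2 by (field; lra). unfold Tg in *. lra. }
  assert (PN : forall f, periodize Tg f (t - s0) = periodize Tg f (t - (s0 + INR n * Tg))).
  { intros f. rewrite <- (periodize_plus_nat Tg f n (t - (s0 + INR n * Tg)) hTg). f_equal. ring. }
  destruct (l3 t rt) as [m1 m2]. split; [|split].
  - rewrite m1. unfold orbit_u. symmetry. apply PN.
  - rewrite m2. unfold orbit_v. symmetry. apply PN.
  - rewrite <- i3, <- (l4 t rt). f_equal. f_equal. unfold orbit_w. apply PN.
Qed.

(* The period of [hw] is a multiple of [loop_time y z], so the exponentially decaying
   difference between [hw] and the shifted [orbit_w] must vanish. *)
Lemma w_follows_orbit a b c d e hu hv hw Th L y z s0 : periodic_data a b c d e hu hv hw Th L ->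
  closing_heights a b e y z -> hu s0 = 0 -> hv s0 = y ->
  forall t, s0 <= t -> hw t = orbit_w a b c d e y z (t - s0).
Proof.
  intros H Hg h0u h0v. pose proof H as (HC & HT & HP & HL & HD). pose proof Hg as (hy & hz & _).
  set (Tg := loop_time y z). assert (hTg : 0 < Tg) by (unfold Tg, loop_time; lra).
  assert (GLOB := follows_orbit a b c d e hu hv hw Th L y z s0 H Hg h0u h0v).
  set (D0 := (hw s0 - orbit_w a b c d e y z 0) * exp s0) in GLOB.
  destruct (GLOB (s0 + Th) ltac:(lra)) as (g1 & g2 & g3).
  destruct (HP s0) as (p1 & p2 & p3). replace (s0 + Th - s0) with Th in g1, g2, g3 by ring.
  rewrite p1, h0u in g1. rewrite p2, h0v in g2.
  assert (SZ : Th - period_base Tg Th = 0).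
  { unfold orbit_u, orbit_v in g1, g2. rewrite periodize_base in g1, g2.
    apply (orbit_pos_v_start a b e y z); auto. apply period_base_range; auto. }
  assert (GW0 : orbit_w a b c d e y z Th = orbit_w a b c d e y z 0).
  { unfold orbit_w. rewrite periodize_base. fold Tg. rewrite SZ. rewrite periodize_in; auto. lra. }
  rewrite p3, GW0 in g3. fold D0 in g3.
  assert (D0z : hw s0 - orbit_w a b c d e y z 0 = 0).
  { unfold D0 in g3. assert (exp s0 < exp (s0 + Th)) by (apply exp_increasing; lra).
    assert ((hw s0 - orbit_w a b c d e y z 0) * (exp (s0 + Th) - exp s0) = 0) by lra.
    apply Rmult_integral in H1. destruct H1; auto. lra. }
  intros t ht. destruct (GLOB t ht) as (_ & _ & k). unfold D0 in k. rewrite D0z, Rmult_0_l in k.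
  apply Rmult_integral in k. destruct k. lra. exfalso. assert (0 < exp t) by apply exp_pos. lra.
Qed.

Lemma same_orbit a b c d e hu hv hw Th L y z s0 : periodic_data a b c d e hu hv hw Th L ->
  closing_heights a b e y z -> hu s0 = 0 -> hv s0 = y ->
  forall x0 y0 z0, on_orbit hu hv hw x0 y0 z0 <->
    on_orbit (orbit_u a b e y z) (orbit_v y z) (orbit_w a b c d e y z) x0 y0 z0.
Proof.
  intros H Hg h0u h0v. pose proof H as (HC & HT & HP & HL & HD). pose proof Hg as (hy & hz & _).
  set (Tg := loop_time y z). assert (hTg : 0 < Tg) by (unfold Tg, loop_time; lra).
  assert (GLOB := follows_orbit a b c d e hu hv hw Th L y z s0 H Hg h0u h0v).
  assert (GLOBW := w_follows_orbit a b c d e hu hv hw Th L y z s0 H Hg h0u h0v).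
  intros x0 y0 z0. split.
  - intros [t (e1 & e2 & e3)]. set (k := (Int_part ((s0 - t) / Th) + 1)%Z).
    destruct (Int_part_bounds ((s0 - t)/Th)) as [f1 f2].
    assert (ht' : s0 <= t + IZR k * Th).
    { unfold k. rewrite plus_IZR. simpl. apply Rmult_lt_compat_r with (r := Th) in f2; [|lra].
      replace ((s0 - t) / Th * Th) with (s0 - t) in f2 by (field; lra). lra. }
    destruct (periodic_data_shift_int _ _ _ _ _ _ _ _ _ _ H k t) as (q1 & q2 & q3).
    destruct (GLOB _ ht') as (m1 & m2 & _). assert (m3 := GLOBW _ ht').
    exists (t + IZR k * Th - s0). split; [|split].
    + rewrite <- m1, q1; auto.
    + rewrite <- m2, q2; auto.
    + rewrite <- m3, q3; auto.
  - intros [t (e1 & e2 & e3)]. set (sg := t - period_base Tg t).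
    assert (hs := period_base_range Tg t hTg). fold sg in hs.
    exists (s0 + sg). destruct (GLOB (s0 + sg) ltac:(lra)) as (m1 & m2 & _).
    assert (m3 := GLOBW (s0 + sg) ltac:(lra)).
    replace (s0 + sg - s0) with sg in m1, m2, m3 by ring.
    assert (RU : orbit_u a b e y z sg = orbit_u a b e y z t)
      by (unfold orbit_u; rewrite (periodize_base _ _ t); fold Tg; rewrite periodize_in; auto).
    assert (RV : orbit_v y z sg = orbit_v y z t)
      by (unfold orbit_v; rewrite (periodize_base _ _ t); fold Tg; rewrite periodize_in; auto).
    assert (RW : orbit_w a b c d e y z sg = orbit_w a b c d e y z t)
      by (unfold orbit_w; rewrite (periodize_base _ _ t); fold Tg; rewrite periodize_in; auto).
    split; [|split]; [rewrite m1, RU| rewrite m2, RV| rewrite m3, RW]; auto.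
Qed.

Lemma orbit_isolated a b c d e y z al de stab : closing_heights a b e y z ->
  Rabs e * ab_norm a b * (2*y+2*z) <= /2 ->
  0 < de -> Rabs (y - al) <= de/2 -> Rabs (z - al) <= de/2 -> monotone_return a b e al de stab ->
  isolated_periodic_orbit a b c d e (orbit_u a b e y z) (orbit_v y z) (orbit_w a b c d e y z).
Proof.
  intros Hg hq hde hyal hzal HS. pose proof Hg as (hy & hz & Ey & Ez & he).
  split. { apply orbit_periodic; auto. }
  set (r := Rmin (Rmin y z / 8) (de/10)).
  assert (hr : 0 < r) by (unfold r; apply Rmin_pos; [assert (0 < Rmin y z) by (apply Rmin_glb_lt;
    lra)|]; lra).
  assert (hr1 : r <= Rmin y z / 8) by apply Rmin_l. assert (hr2 : r <= de/10) by apply Rmin_r.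
  exists r. split; auto.
  intros hu hv hw Hh Ht.
  destruct (periodic_orbit_data _ _ _ _ _ _ _ _ Hh) as [Th [L H]].
  destruct (near_orbit_axes a b e y z hu hv hw r (orbit_w a b c d e y z) Hg hq hr hr1 Ht) as (NO & T1 & T2).
  assert (AH := pos_v_crossing_height _ _ _ _ _ _ _ _ _ _ y z al de stab H he Ey Ez HS
     ltac:(intros s h1 h2; assert (k := T1 s h1 h2); apply Rabs_def2 in k;
           apply Rabs_le_between in hyal; apply Rabs_le_between; lra)
     ltac:(intros s h1 h2; assert (k := T2 s h1 h2); apply Rabs_def2 in k;
           apply Rabs_le_between in hzal; apply Rabs_le_between; lra)
     ltac:(lra) ltac:(lra)).
  destruct (reaches_pos_v_axis _ _ _ _ _ _ _ _ _ _ H he NO) as [s0 [h0u h0v]].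
  apply (same_orbit a b c d e hu hv hw Th L y z s0); auto.
Qed.

(** * Position of the explicit orbit *)

Definition cd_norm (c d : nat -> R) :=
  1 + Rabs (c 1%nat) + Rabs (c 2%nat) + Rabs (c 3%nat) + Rabs (c 4%nat)
  + Rabs (d 1%nat) + Rabs (d 2%nat) + Rabs (d 3%nat) + Rabs (d 4%nat).

Lemma cd_norm_bounds c d : 1 <= cd_norm c d /\
  Rabs (c 1%nat) <= cd_norm c d /\ Rabs (c 2%nat) <= cd_norm c d /\ Rabs (c 3%nat) <= cd_norm c d
    /\ Rabs (c 4%nat) <= cd_norm c d /\
  Rabs (d 1%nat) <= cd_norm c d /\ Rabs (d 2%nat) <= cd_norm c d /\ Rabs (d 3%nat) <= cd_norm c d
    /\ Rabs (d 4%nat) <= cd_norm c d.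
Proof.
  unfold cd_norm. assert (h1 := Rabs_pos (c 1%nat)). assert (h2 := Rabs_pos (c 2%nat)).
  assert (h3 := Rabs_pos (c 3%nat)). assert (h4 := Rabs_pos (c 4%nat)).
  assert (h5 := Rabs_pos (d 1%nat)). assert (h6 := Rabs_pos (d 2%nat)).
  assert (h7 := Rabs_pos (d 3%nat)). assert (h8 := Rabs_pos (d 4%nat)). repeat split; lra.
Qed.

Lemma w_coeff_bounds a b c d e j : Rabs e * ab_norm a b <= /2 -> (j = 1 \/ j = 2 \/ j = 3 \/ j = 4)%nat ->
  Rabs (w_slope a c e j) <= 2 * (Rabs e * cd_norm c d) /\ Rabs (w_offset a b c d e j)
    <= 4 * (Rabs e * cd_norm c d).
Proof.
  intros he hj. destruct (cd_norm_bounds c d) as (h0 & c1 & c2 & c3 & c4 & d1 & d2 & d3 & d4).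
  destruct (rate_bounds a b e) as (q1 & q2 & q3 & q4 & _).
  destruct (drift_signs a b e he) as (p1 & p2 & p3 & p4 & t1 & t2 & t3 & t4).
  assert (Hc : Rabs (c j) <= cd_norm c d) by (destruct hj as [ -> | [ -> | [ -> | -> ] ] ]; auto).
  assert (Hd : Rabs (d j) <= cd_norm c d) by (destruct hj as [ -> | [ -> | [ -> | -> ] ] ]; auto).
  assert (Hq : /2 <= 1 + rate a e j).
  { destruct hj as [ -> | [ -> | [ -> | -> ] ] ]; [apply Rabs_le_between in q1| apply Rabs_le_between in q2|
      apply Rabs_le_between in q3| apply Rabs_le_between in q4]; lra. }
  assert (Hp : Rabs (drift b e j) <= 3/2).
  { destruct hj as [ -> | [ -> | [ -> | -> ] ] ]; unfold drift, su;
      [apply Rabs_le_between in t1| apply Rabs_le_between in t2| apply Rabs_le_between in t3| apply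
        Rabs_le_between in t4];
      apply Rabs_le_between; lra. }
  assert (0 <= Rabs e) by apply Rabs_pos.
  assert (A1 : Rabs (w_slope a c e j) <= 2 * (Rabs e * cd_norm c d)).
  { unfold w_slope. unfold Rdiv. rewrite Rabs_mult, Rabs_mult, Rabs_inv, (Rabs_right (1 + rate a e j)) by lra.
    apply Rmult_le_reg_r with (1 + rate a e j). lra.
    replace (Rabs e * Rabs (c j) * / (1 + rate a e j) * (1 + rate a e j)) with (Rabs e * Rabs (c j))
      by (field; lra).
    assert (Rabs e * Rabs (c j) <= Rabs e * cd_norm c d) by (apply Rmult_le_compat_l; auto).
    assert (0 <= Rabs e * cd_norm c d) by (apply Rmult_le_pos; lra). nra. }
  split; auto. unfold w_offset.
  unfold Rminus. eapply Rle_trans. apply Rabs_triang. rewrite Rabs_Ropp, Rabs_mult, Rabs_mult.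
  assert (Rabs e * Rabs (d j) <= Rabs e * cd_norm c d) by (apply Rmult_le_compat_l; auto).
  assert (Rabs (w_slope a c e j) * Rabs (drift b e j) <= 2 * (Rabs e * cd_norm c d) * (3/2))
    by (apply Rmult_le_compat; auto; apply Rabs_pos).
  lra.
Qed.

Lemma w_value_bound_alg al4 x be4 KA S1 S2 S3 be1 be2 E1 E2 E3 E4 E5 E6 g ep M :
  Rabs al4 <= 2*ep -> Rabs x <= M -> Rabs be4 <= 4*ep -> Rabs be1 <= 4*ep -> Rabs be2 <= 4*ep ->
  Rabs S1 <= ep*(4*M+8) -> Rabs S2 <= 8*ep -> Rabs S3 <= ep*(4*M+8) ->
  0 < E1 <= 1 -> 0 < E2 <= 1 -> 0 < E3 <= 1 -> 0 < E4 <= 1 -> 0 < E5 <= 1 -> 0 < E6 <= 1 ->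
  0 < g -> 0 <= ep -> 0 <= M ->
  KA = (be1 - be2 + S1 * E1 + S2 * E2 + S3 * E3) / g ->
  Rabs (al4 * x + be4 + KA * E4 + S1 * E5 + S2 * E6) <= ep * (6*M + 20 + (8*M+32)/g).
Proof.
  intros h1 h2 h3 h4 h5 h6 h7 h8 k1 k2 k3 k4 k5 k6 hg hep hM HK.
  assert (B : forall u E U, Rabs u <= U -> 0 < E <= 1 -> Rabs (u * E) <= U).
  { intros u E U hu hE. rewrite Rabs_mult, (Rabs_right E) by lra. assert (0 <= Rabs u)
    by apply Rabs_pos. nra. }
  assert (KAb : Rabs KA <= ep * (8*M+32) / g).
  { rewrite HK. unfold Rdiv. rewrite Rabs_mult, Rabs_inv, (Rabs_right g) by lra.
    apply Rmult_le_compat_r. left; apply Rinv_0_lt_compat; auto.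
    assert (q1 := B S1 E1 _ h6 k1). assert (q2 := B S2 E2 _ h7 k2). assert (q3 := B S3 E3 _ h8 k3).
    apply Rabs_le_between in q1, q2, q3, h4, h5. apply Rabs_le_between. split; nra. }
  assert (q4 := B KA E4 _ KAb k4). assert (q5 := B S1 E5 _ h6 k5). assert (q6 := B S2 E6 _ h7 k6).
  assert (q7 : Rabs (al4 * x) <= 2*ep*M) by (apply Rabs_mult_le; auto).
  apply Rabs_le_between in q4, q5, q6, q7, h3. apply Rabs_le_between.
  assert (ep * (8 * M + 32) / g = ep * ((8*M+32)/g)) by (field; lra). split; nra.
Qed.

Lemma u_cross_bounds a b e y z : closing_heights a b e y z ->
  Rabs e * ab_norm a b * (2*y+2*z) <= /2 ->
  Rabs (u_neg_cross a b e y z) <= 3*(y+z)+1 /\ Rabs (u_pos_cross a b e y z) <= 3*(y+z)+1.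
Proof.
  intros H hq. pose proof H as (hy & hz & _ & _ & he).
  destruct (drift_signs a b e he) as (_ & _ & _ & _ & _ & t2 & _ & t4).
  destruct (rate_bounds a b e) as (_ & q2 & _ & q4 & _).
  split.
  - unfold u_neg_cross, uA, u_arc. replace (y - 0) with y by ring.
    destruct (expm1_div_bounds (rate a e 2) y hy) as [[k1 k2] _].
    { assert (Rabs (rate a e 2) * y <= Rabs e * ab_norm a b * (2*y+2*z))
        by (apply Rmult_le_compat; try lra; apply Rabs_pos). lra. }
    rewrite Rabs_mult, (Rabs_right (expm1_div _ _)) by lra.
    apply Rabs_le_between in t2. rewrite drift2, Rabs_left by lra.
    assert (- (-1 + e * b 2%nat) * expm1_div (rate a e 2) y <= 3/2 * (2*y))
      by (apply Rmult_le_compat; lra). lra.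
  - unfold u_pos_cross, uC, u_arc. replace (y + 2*z - (y + z)) with z by ring.
    destruct (expm1_div_bounds (rate a e 4) z hz) as [[k1 k2] _].
    { assert (Rabs (rate a e 4) * z <= Rabs e * ab_norm a b * (2*y+2*z))
        by (apply Rmult_le_compat; try lra; apply Rabs_pos). lra. }
    rewrite Rabs_mult, (Rabs_right (expm1_div _ _)) by lra.
    apply Rabs_le_between in t4. rewrite drift4, Rabs_right by lra.
    assert ((1 + e * b 4%nat) * expm1_div (rate a e 4) z <= 3/2 * (2*z))
      by (apply Rmult_le_compat; lra). lra.
Qed.

Lemma orbit_w_cross_bound a b c d e y z : closing_heights a b e y z
  -> Rabs e * ab_norm a b * (2*y+2*z) <= /2 ->
  Rabs (orbit_w a b c d e y z (y + 2*z)) <= Rabs e * cd_norm c d * (6*(3*(y+z)+1)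
    + 20 + (8*(3*(y+z)+1)+32)/(1 - exp (- (2*y+2*z)))).
Proof.
  intros H hq. pose proof H as (hy & hz & Ey & Ez & he).
  destruct (drift_signs a b e he) as (p1 & p2 & p3 & p4 & t1 & t2 & t3 & t4).
  destruct (rate_bounds a b e) as (q1 & q2 & q3 & q4 & _).
  assert (hT : 0 < loop_time y z) by (unfold loop_time; lra).
  assert (GT : 0 < 1 - exp (- (2*y+2*z))) by (assert (exp (-(2*y+2*z)) < 1) by (rewrite <- exp_0;
    apply exp_increasing; lra); lra).
  unfold orbit_w. rewrite periodize_in by (unfold loop_time; lra). unfold w_loop. rewrite concat4_C by lra.
  set (ep := Rabs e * cd_norm c d). set (M := 3*(y+z)+1).
  assert (hep : 0 <= ep) by (unfold ep; apply Rmult_le_pos;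
    [apply Rabs_pos| destruct (cd_norm_bounds c d); lra]).
  assert (AB : forall j, (j = 1 \/ j = 2 \/ j = 3 \/ j = 4)%nat -> Rabs (w_slope a c e j) <= 2 * ep
    /\ Rabs (w_offset a b c d e j) <= 4 * ep)
    by (intros; apply w_coeff_bounds; auto).
  destruct (AB 1%nat ltac:(auto)) as [a1 b1']. destruct (AB 2%nat ltac:(auto)) as [a2 b2'].
  destruct (AB 3%nat ltac:(auto)) as [a3 b3']. destruct (AB 4%nat ltac:(auto)) as [a4 b4'].
  destruct (u_cross_bounds a b e y z H hq) as [Hm Hx]. fold M in Hm, Hx.
  assert (HM : 0 <= M) by (unfold M; lra).
  set (S1 := w_slope a c e 2 * u_neg_cross a b e y z + w_offset a b c d e 2 - w_slope a c e 3 *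
    u_neg_cross a b e y z - w_offset a b c d e 3).
  set (S2 := w_offset a b c d e 3 - w_offset a b c d e 4).
  set (S3 := w_slope a c e 4 * u_pos_cross a b e y z + w_offset a b c d e 4 - w_slope a c e 1 *
    u_pos_cross a b e y z - w_offset a b c d e 1).
  assert (hS1 : Rabs S1 <= ep * (4*M+8)).
  { unfold S1. assert (k1 := Rabs_mult_le _ _ _ _ a2 Hm). assert (k2 := Rabs_mult_le _ _ _ _ a3 Hm).
    apply Rabs_le_between in k1, k2, b2', b3'. apply Rabs_le_between. split; nra. }
  assert (hS2 : Rabs S2 <= 8 * ep).
  { unfold S2. apply Rabs_le_between in b3', b4'. apply Rabs_le_between. split; lra. }
  assert (hS3 : Rabs S3 <= ep * (4*M+8)).
  { unfold S3. assert (k1 := Rabs_mult_le _ _ _ _ a4 Hx). assert (k2 := Rabs_mult_le _ _ _ _ a1 Hx).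
    apply Rabs_le_between in k1, k2, b4', b1'. apply Rabs_le_between. split; nra. }
  assert (EX : forall u, 0 <= u -> 0 < exp (- u) <= 1).
  { intros u hu. split. apply exp_pos. rewrite <- exp_0. apply exp_le_mono. lra. }
  unfold wC, w_arc. fold (uC a b e y z).
  replace (uC a b e y z (y + 2*z)) with (u_pos_cross a b e y z) by reflexivity.
  replace (KC a b c d e y z * exp (- (y + 2 * z))) with
    (KA a b c d e y z * exp (- (y + 2*z)) + S1 * exp (- (2*z)) + S2 * exp (- z)).
  2: { unfold KC, KB, J1, J2. fold S1 S2.
       replace (exp (- (2*z))) with (exp y * exp (- (y + 2*z))) by (rewrite <- exp_plus; f_equal; ring).
       replace (exp (- z)) with (exp (y+z) * exp (- (y + 2*z))) by (rewrite <- exp_plus; f_equal;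
         ring). ring. }
  rewrite <- !Rplus_assoc.
  apply (w_value_bound_alg _ _ _ _ _ _ S3 (w_offset a b c d e 1) (w_offset a b c d e 2)
    (exp (- (y + 2*z))) (exp (- (y+z))) (exp (- y)) _ _ _ _ ep M);
    auto; try (apply EX; lra).
  unfold KA, J1, J2, J3, loop_time. fold S1 S2 S3.
  replace (exp (- (y + 2*z))) with (exp y * exp (- (2*y+2*z))) by (rewrite <- exp_plus; f_equal; ring).
  replace (exp (- (y + z))) with (exp (y+z) * exp (- (2*y+2*z))) by (rewrite <- exp_plus; f_equal; ring).
  replace (exp (- y)) with (exp (y + 2*z) * exp (- (2*y+2*z))) by (rewrite <- exp_plus; f_equal; ring).
  field. lra.
Qed.

Lemma u_pos_cross_approx a b e z : 0 < z -> Rabs e * ab_norm a b * (2*z) <= /2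
  -> Rabs e * ab_norm a b <= /2 ->
  Rabs (drift b e 4 * expm1_div (rate a e 4) z - z) <= Rabs e * ab_norm a b * (2*z^2 + 2*z).
Proof.
  intros hz hq he. destruct (rate_bounds a b e) as (_ & _ & _ & q4 & _ & _ & _ & c4).
  destruct (expm1_div_mvt (rate a e 4) 0 z hz) as [xi [hxi m]]. rewrite expm1_div_0 in m.
  assert (hq4 : Rabs (rate a e 4) * z <= /2).
  { assert (Rabs (rate a e 4) * z <= Rabs e * ab_norm a b * z) by (apply Rmult_le_compat_r; lra).
    assert (0 <= Rabs e * ab_norm a b) by (apply Rmult_le_pos;
      [apply Rabs_pos| destruct (ab_norm_bounds a b); lra]). nra. }
  assert (hxi' : Rabs (rate a e 4 * xi) <= Rabs (rate a e 4) * z).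
  { rewrite Rabs_mult, (Rabs_right xi) by lra. apply Rmult_le_compat_l. apply Rabs_pos. lra. }
  assert (k := Rabs_exp_sub1_le (rate a e 4 * xi) ltac:(lra)).
  destruct (expm1_div_bounds (rate a e 4) z hz hq4) as [[f1 f2] _].
  rewrite drift4.
  replace ((1 + e * b 4%nat) * expm1_div (rate a e 4) z - z) with ((expm1_div (rate a e 4)
    z - 0 - z) + e * b 4%nat * expm1_div (rate a e 4) z) by ring.
  rewrite m. replace ((z - 0) * exp (rate a e 4 * xi) - z) with (z * (exp (rate a e 4 * xi) - 1)) by ring.
  eapply Rle_trans. apply Rabs_triang.
  assert (r1 : Rabs (z * (exp (rate a e 4 * xi) - 1)) <= z * (2 * (Rabs e * ab_norm a b * z))).
  { rewrite Rabs_mult, (Rabs_right z) by lra. apply Rmult_le_compat_l. lra.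
    assert (Rabs (rate a e 4) * z <= Rabs e * ab_norm a b * z) by (apply Rmult_le_compat_r; lra). lra. }
  assert (r2 : Rabs (e * b 4%nat * expm1_div (rate a e 4) z) <= Rabs e * ab_norm a b * (2 * z)).
  { rewrite Rabs_mult, (Rabs_right (expm1_div _ _)) by lra. apply Rmult_le_compat. apply Rabs_pos.
    lra. auto. lra. }
  assert (z * (2 * (Rabs e * ab_norm a b * z)) = Rabs e * ab_norm a b * (2 * z^2)) by ring. nra.
Qed.

Lemma dist3_on_axis_le x y z al : y = 0 -> dist3 x y z al 0 0 <= Rabs (x - al) + Rabs z.
Proof.
  intros ->. unfold dist3. rewrite !Rminus_0_r.
  assert (0 <= Rabs (x - al) + Rabs z) by (assert (h1 := Rabs_pos (x - al)); assert (h2 := Rabs_pos z); lra).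
  rewrite <- (sqrt_Rsqr (Rabs (x - al) + Rabs z)) by auto. apply sqrt_le_1_alt. unfold Rsqr.
  assert (0 <= Rabs (x - al) * Rabs z) by (apply Rmult_le_pos; apply Rabs_pos).
  rewrite <- (pow2_abs (x - al)), <- (pow2_abs z). simpl. nra.
Qed.

Lemma closing_heights_small_eps a b : a_sum a <> 0 -> 0 < alpha_star a b ->
  exists eps0 C1 de, 0 < eps0 /\ 0 < C1 /\ 0 < de /\ forall e, 0 < Rabs e < eps0 ->
    exists y z stab, closing_heights a b e y z /\
      Rabs e * ab_norm a b * (2*y+2*z) <= /2 /\
      Rabs (y - alpha_star a b) <= de/2 /\ Rabs (z - alpha_star a b) <= de/2 /\
      de <= alpha_star a b / 2 /\ monotone_return a b e (alpha_star a b) de stab /\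
      Rabs (y - alpha_star a b) <= C1 * Rabs e /\ Rabs (z - alpha_star a b) <= C1 * Rabs e.
Proof.
  intros Hsa Hal.
  destruct (return_map_monotone a b Hsa Hal) as [de [e2 (hde & hde2 & he2 & HS)]].
  destruct (transit_fixed_point a b Hsa Hal) as [e1 [C1 (he1 & hC1 & HE)]].
  set (al := alpha_star a b) in *. set (A := ab_norm a b).
  assert (hA : 1 <= A) by apply ab_norm_bounds.
  set (eps0 := Rmin (Rmin e1 e2) (Rmin (de/(2*C1)) (Rmin (/(10*A*al)) (/(2*A))))).
  exists eps0, C1, de. split.
  { unfold eps0. repeat apply Rmin_pos; auto. apply Rdiv_lt_0_compat; lra.
    apply Rinv_0_lt_compat. nra. apply Rinv_0_lt_compat. lra. }
  split; auto. split; auto. intros e He.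
  assert (Hmin : forall m, eps0 <= m -> Rabs e < m) by (intros m hm; lra).
  assert (He1 : Rabs e < e1) by (apply Hmin; unfold eps0; eapply Rle_trans; apply Rmin_l).
  assert (He2 : Rabs e < e2) by (apply Hmin; unfold eps0; eapply Rle_trans; [apply Rmin_l| apply Rmin_r]).
  assert (He3 : Rabs e < de/(2*C1)) by (apply Hmin; unfold eps0; eapply Rle_trans;
    [apply Rmin_r| apply Rmin_l]).
  assert (He4 : Rabs e < /(10*A*al))
    by (apply Hmin; unfold eps0; eapply Rle_trans; [apply Rmin_r|]; eapply Rle_trans;
      [apply Rmin_r| apply Rmin_l]).
  assert (He5 : Rabs e < /(2*A))
    by (apply Hmin; unfold eps0; eapply Rle_trans; [apply Rmin_r|]; eapply Rle_trans; apply Rmin_r).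
  destruct (HE e ltac:(split; [apply He| auto])) as [y [z (Ey & Ez & hy & hz & dy & dz)]].
  destruct (HS e ltac:(split; [apply He| auto])) as [stab Hst].
  assert (HC1e : C1 * Rabs e <= de / 2).
  { apply Rmult_lt_compat_l with (r := C1) in He3; auto.
    replace (C1 * (de / (2*C1))) with (de/2) in He3 by (field; lra). lra. }
  assert (yb := dy). assert (zb := dz). apply Rabs_le_between in yb, zb.
  assert (heA : Rabs e * A <= /2).
  { apply Rmult_lt_compat_r with (r := A) in He5; [|lra].
    replace (/ (2 * A) * A) with (/2) in He5 by (field; lra). lra. }
  assert (hq : Rabs e * A * (2*y+2*z) <= /2).
  { assert (k : Rabs e * (10*A*al) < 1).
    { apply Rmult_lt_compat_r with (r := 10*A*al) in He4; [|nra]. rewrite Rinv_l in He4 by nra. lra. }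
    assert (0 <= Rabs e * A) by (apply Rmult_le_pos; [apply Rabs_pos| lra]).
    assert (Rabs e * A * (2*y+2*z) <= Rabs e * A * (5 * al)) by (apply Rmult_le_compat_l; lra). nra. }
  exists y, z, stab.
  refine (conj _ (conj hq (conj _ (conj _ (conj hde2 (conj Hst (conj dy dz)))))));
    [unfold closing_heights; fold A; repeat split; auto| lra| lra].
Qed.

Lemma orbit_u_start a b e y z : 0 < y -> 0 < z -> orbit_u a b e y z 0 = 0.
Proof.
  intros hy hz. unfold orbit_u. rewrite periodize_in by (unfold loop_time; lra).
  unfold u_loop. rewrite concat4_A by lra. unfold uA, u_arc. rewrite Rminus_0_r, expm1_div_0. ring.
Qed.

Lemma orbit_cross_near_alpha a b c d C1 : 0 < alpha_star a b -> 0 <= C1 ->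
  exists C, 0 < C /\ forall e y z, closing_heights a b e y z ->
    Rabs e * ab_norm a b * (2*y+2*z) <= /2 ->
    Rabs (y - alpha_star a b) <= C1 * Rabs e -> Rabs (z - alpha_star a b) <= C1 * Rabs e ->
    3 * alpha_star a b / 4 <= y <= 5 * alpha_star a b / 4 ->
    3 * alpha_star a b / 4 <= z <= 5 * alpha_star a b / 4 ->
    dist3 (orbit_u a b e y z (y + 2*z)) (orbit_v y z (y + 2*z)) (orbit_w a b c d e y z (y + 2*z))
      (alpha_star a b) 0 0 <= C * Rabs e.
Proof.
  intros Hal hC1. set (al := alpha_star a b) in *. set (A := ab_norm a b). set (Cdd := cd_norm c d).
  assert (hA : 1 <= A) by apply ab_norm_bounds. assert (hCd : 1 <= Cdd) by apply cd_norm_bounds.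
  set (Mb := 3 * (5 * al / 2) + 1). set (g0 := 1 - exp (- (3 * al))).
  assert (hg0 : 0 < g0).
  { unfold g0. assert (exp (- (3*al)) < 1) by (rewrite <- exp_0; apply exp_increasing; lra). lra. }
  assert (hMb : 0 <= Mb) by (unfold Mb; lra).
  assert (hC' : 0 <= Cdd*(6*Mb + 20 + (8*Mb+32)/g0)).
  { apply Rmult_le_pos. lra. assert (0 <= (8*Mb+32)/g0) by (apply Rdiv_le_0_compat; lra). lra. }
  exists (C1 + A*(8*al^2+4*al) + Cdd*(6*Mb + 20 + (8*Mb+32)/g0)). split.
  { assert (0 < A*(8*al^2+4*al)) by (apply Rmult_lt_0_compat; nra). lra. }
  intros e y z Hg hq dy dz yb zb. pose proof Hg as (hy & hz & _ & _ & heA).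
  assert (GUx : orbit_u a b e y z (y + 2*z) = drift b e 4 * expm1_div (rate a e 4) z).
  { unfold orbit_u. rewrite periodize_in by (unfold loop_time; lra). unfold u_loop. rewrite concat4_C by lra.
    unfold uC, u_arc. f_equal. f_equal. ring. }
  assert (GVx : orbit_v y z (y + 2*z) = 0).
  { unfold orbit_v. rewrite periodize_in by (unfold loop_time; lra). unfold v_loop.
    rewrite concat4_C by lra. unfold vC. ring. }
  eapply Rle_trans. { apply dist3_on_axis_le. auto. } rewrite GUx.
  assert (X1 := u_pos_cross_approx a b e z hz ltac:(fold A; nra) heA). fold A in X1.
  assert (W1 := orbit_w_cross_bound a b c d e y z Hg hq). fold A Cdd in W1.
  assert (Xb : Rabs (drift b e 4 * expm1_div (rate a e 4) z - al) <= Rabs e * (C1 + A * (8 * al^2 + 4*al))).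
  { replace (drift b e 4 * expm1_div (rate a e 4) z - al)
      with ((drift b e 4 * expm1_div (rate a e 4) z - z) + (z - al)) by ring.
    eapply Rle_trans. apply Rabs_triang.
    assert (0 <= Rabs e * A) by (apply Rmult_le_pos; [apply Rabs_pos| lra]).
    assert (Rabs e * A * (2*z^2 + 2*z) <= Rabs e * A * (8*al^2 + 4*al)) by (apply Rmult_le_compat_l;
      nra). nra. }
  assert (Wb : Rabs (orbit_w a b c d e y z (y + 2 * z)) <= Rabs e * (Cdd*(6*Mb + 20 + (8*Mb+32)/g0))).
  { eapply Rle_trans. apply W1.
    set (M := 3 * (y + z) + 1). set (g := 1 - exp (- (2 * y + 2 * z))).
    assert (hM : M <= Mb) by (unfold M, Mb; lra).
    assert (hg : g0 <= g).
    { unfold g, g0. assert (exp (- (2*y+2*z)) <= exp (- (3*al))) by (apply exp_le_mono; lra). lra. }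
    assert (hfrac : (8*M+32)/g <= (8*Mb+32)/g0).
    { unfold Rdiv. apply Rmult_le_compat. unfold M; lra. left; apply Rinv_0_lt_compat; lra. lra.
      apply Rinv_le_contravar; lra. }
    assert (0 <= Rabs e * Cdd) by (apply Rmult_le_pos; [apply Rabs_pos| lra]).
    replace (Rabs e * (Cdd * (6 * Mb + 20 + (8 * Mb + 32) / g0)))
      with (Rabs e * Cdd * (6 * Mb + 20 + (8 * Mb + 32) / g0)) by ring.
    apply Rmult_le_compat_l; auto. lra. }
  lra.
Qed.

Theorem mainTheorem10 (a b c d : nat -> R) :
  a 1%nat + a 2%nat + a 3%nat + a 4%nat <> 0 ->
  0 < alpha_star a b ->
  exists eps0 C : R, 0 < eps0 /\ 0 < C /\
    forall eps : R, 0 < Rabs eps < eps0 ->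
      exists gu gv gw : R -> R,
        isolated_periodic_orbit a b c d eps gu gv gw /\
        (exists t, gu t * gv t = 0) /\
        (exists t, dist3 (gu t) (gv t) (gw t) (alpha_star a b) 0 0 <= C * Rabs eps).
Proof.
  intros Hsa Hal. change (a_sum a <> 0) in Hsa.
  destruct (closing_heights_small_eps a b Hsa Hal) as (eps0 & C1 & de & he0 & hC1 & hde & Hsmall).
  destruct (orbit_cross_near_alpha a b c d C1 Hal ltac:(lra)) as (C & hC & Hcross).
  exists eps0, C. split; [auto|]. split; [auto|]. intros e He.
  destruct (Hsmall e He) as (y & z & stab & Hg & hq & dy & dz & hde2 & Hst & ey & ez).
  pose proof Hg as (hy & hz & _).
  exists (orbit_u a b e y z), (orbit_v y z), (orbit_w a b c d e y z). split; [|split].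
  - apply (orbit_isolated a b c d e y z (alpha_star a b) de stab); auto.
  - exists 0. rewrite orbit_u_start by auto. ring.
  - exists (y + 2*z). apply Hcross; auto; apply Rabs_le_between in dy, dz; lra.
Qed.
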